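(* Let $a,b,c\geq 1$ be integers, put $v=a+b+c+1$ and $L=\{1^a,2^b,6^c\}$, and suppose $6\leq\lfloor v/2\rfloor$. Then there exists a Hamiltonian path $H$ of $K_v$ with $\ell(H)=L$ if and only if for every divisor $d$ of $v$, the number of elements of $L$ (with multiplicity) that are multiples of $d$ does not exceed $v-d$.
   Context: $K_v$ is the complete graph on $\{0,1,\dots,v-1\}$. The length of an edge $[x,y]$ is $\ell(x,y)=\min(|x-y|,\,v-|x-y|)$, and for a subgraph $\Gamma$, $\ell(\Gamma)$ is the multiset of lengths of its edges. $\{1^a,2^b,6^c\}$ is the multiset with $a$ copies of $1$, $b$ copies of $2$, $c$ copies of $6$. (The paper phrases this as ''$\mathrm{BHR}(\{1^a,2^b,6^c\})$ holds''.) *)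

From mathcomp Require Import all_boot.
Set Implicit Arguments. Unset Strict Implicit. Unset Printing Implicit Defensive.

Definition edge_len (v x y : nat) : nat :=
  let d := maxn x y - minn x y in minn d (v - d).

Definition ham_path (v : nat) (p : seq nat) : Prop := perm_eq p (iota 0 v).

Definition path_lengths (v : nat) (p : seq nat) : seq nat :=
  match p with
  | [::] => [::]
  | x :: s => pairmap (edge_len v) x s
  end.

Definition L126 (a b c : nat) : seq nat := nseq a 1 ++ nseq b 2 ++ nseq c 6.

From mathcomp Require Import all_boot zify.
Set Implicit Arguments. Unset Strict Implicit. Unset Printing Implicit Defensive.

(* Necessity: an edge whose length is a multiple of d (d | v) joins two vertices of the same
   residue class mod d; a Hamiltonian path meets all d classes, so at least d - 1 of its v - 1
   edges have a length not divisible by d.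

   Say a Hamiltonian path of K_v with all lengths at
   most m has a block of width k at the cut G if it contains the k edges {G - k + j, G + j}
   (j < k) and every other edge either lies on one side of the cut or wraps around
   (linear distance > m).  Insert k new vertices at G, moving every vertex >= G up by k, and
   route each block edge G - k + j -- G + j + k through the new vertex G + j: this is a
   Hamiltonian path of K_(v+k) with k more edges of length k, a block of width k at G + k, and
   the blocks at cuts far enough from G survive.  A realisation of (a, b, c) carrying blocks of
   widths 1, 2 and 6 therefore grows to (a + 1, b, c), (a, b + 2, c) and (a, b, c + 6); the
   finitely many base cases a <= 9, b <= 11, c <= 14 are checked by computation. *)

Definition edges (p : seq nat) : seq (nat * nat) :=
  if p is x :: s then pairmap pair x s else [::].

Definition sort_edge (e : nat * nat) : nat * nat := (minn e.1 e.2, maxn e.1 e.2).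

Definition uedges (p : seq nat) : seq (nat * nat) := map sort_edge (edges p).

Lemma uedges_cons2 x y s : uedges [:: x, y & s] = sort_edge (x, y) :: uedges (y :: s).
Proof. by []. Qed.

Lemma sort_edge_le e : (sort_edge e).1 <= (sort_edge e).2.
Proof. exact: leq_trans (geq_minl _ _) (leq_maxl _ _). Qed.

Lemma edge_len_sort v e : edge_len v (sort_edge e).1 (sort_edge e).2 = edge_len v e.1 e.2.
Proof. by rewrite {1}/edge_len (maxn_idPr (sort_edge_le e)) (minn_idPl (sort_edge_le e)). Qed.

Lemma path_lengthsE v p : path_lengths v p = [seq edge_len v e.1 e.2 | e <- uedges p].
Proof.
case: p => // x s; rewrite /uedges -map_comp; elim: s x => //= y s IH x.
by rewrite IH /= -(edge_len_sort v (x, y)).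
Qed.

Lemma mem_uedges p e : e \in uedges p -> (e.1 \in p) && (e.2 \in p).
Proof.
case: p => // x s /mapP [[x' y'] /= e_edge ->] /=.
have /andP [x'_p y'_p] : (x' \in x :: s) && (y' \in x :: s).
  elim: s x e_edge => //= y s IH x; rewrite in_cons => /orP [/eqP [-> ->] | /IH].
    by rewrite !in_cons !eqxx /= ?orbT.
  by case/andP=> x'_s y'_s; rewrite in_cons x'_s orbT in_cons y'_s orbT.
by case: leqP => _; rewrite x'_p y'_p.
Qed.

Lemma uniq_uedges p : uniq p -> uniq (uedges p).
Proof.
case: p => // x s; elim: s x => // y s IH x /andP [x_ys ys_uniq].
rewrite uedges_cons2 cons_uniq IH // andbT.
apply: contra x_ys => /mem_uedges /andP []; rewrite /sort_edge /=.
by case: leqP => _ //= _; rewrite in_cons eqxx.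
Qed.

Lemma flatten_map_if_perm (T U : eqType) (P : pred T) (f : T -> U) c s :
  perm_eq (flatten [seq if P e then [:: f e; c] else [:: f e] | e <- s])
          (map f s ++ nseq (count P s) c).
Proof.
apply/permP => Q; elim: s => //= e s IH.
rewrite count_cat IH; case: (P e); rewrite /= !count_cat /= ?add0n; lia.
Qed.

Definition shift_from (G k x : nat) : nat := if x < G then x else x + k.

Definition in_block (G k lo hi : nat) : bool := (hi - lo == k) && (G <= hi < G + k).

(* An edge of linear distance > m can only be a wrap-around
   edge (of cyclic length v - (hi - lo)) and must cross the cut; a shorter edge may cross it
   only as a block edge. *)
Definition fits_cut (m G k lo hi : nat) : bool :=
  if hi - lo <= m then (lo < G <= hi) ==> in_block G k lo hi else lo < G <= hi.

Definition apart (G H n : nat) : bool := (H + n <= G) || (G + n <= H).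

Lemma shift_from_mono G k : {homo shift_from G k : x y / x <= y}.
Proof. by move=> x y; rewrite /shift_from; case: (ltnP x G); case: (ltnP y G); lia. Qed.

Lemma shift_from_inj G k : injective (shift_from G k).
Proof. by move=> x y; rewrite /shift_from; case: (ltnP x G); case: (ltnP y G); lia. Qed.

Lemma edge_len_sorted v lo hi : lo <= hi -> edge_len v lo hi = minn (hi - lo) (v - (hi - lo)).
Proof. by move=> le_lh; rewrite /edge_len (maxn_idPr le_lh) (minn_idPl le_lh). Qed.

Ltac cut_lia :=
  rewrite /shift_from /fits_cut /in_block /apart;
  repeat match goal with |- context [if ?a < ?b then _ else _] => case: (ltnP a b) => ? end;
  repeat case: ifP => ?; move=> *; repeat split; lia.

Lemma in_block_le G k lo hi : in_block G k lo hi -> lo < G <= hi.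
Proof. by rewrite /in_block; lia. Qed.

Lemma in_block_edge_len v G k lo hi : k.*2 <= v -> in_block G k lo hi ->
  [/\ edge_len v lo hi = k, edge_len (v + k) lo hi = k & edge_len (v + k) hi (hi + k) = k].
Proof.
move=> k2_le_v blk; have le_lh : lo <= hi by have := in_block_le blk; lia.
by rewrite !edge_len_sorted ?leq_addr //; move: blk; cut_lia.
Qed.

Lemma shift_edge_len m v G k lo hi : m.*2 <= v -> lo <= hi -> edge_len v lo hi <= m ->
  fits_cut m G k lo hi -> ~~ in_block G k lo hi ->
  edge_len (v + k) (shift_from G k lo) (shift_from G k hi) = edge_len v lo hi.
Proof. by move=> m2_le_v le_lh; rewrite !edge_len_sorted ?shift_from_mono //; cut_lia. Qed.

Lemma in_block_fits_next m G k lo hi : k <= m -> in_block G k lo hi ->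
  fits_cut m (G + k) k lo hi && fits_cut m (G + k) k hi (hi + k).
Proof. by cut_lia. Qed.

Lemma shift_fits_next m G k lo hi : lo <= hi -> fits_cut m G k lo hi -> ~~ in_block G k lo hi ->
  fits_cut m (G + k) k (shift_from G k lo) (shift_from G k hi).
Proof. by cut_lia. Qed.

Lemma in_block_fits_apart m G k H k' lo hi :
  k <= m -> apart G H (maxn k k') -> in_block G k lo hi ->
  fits_cut m (shift_from G k H) k' lo hi && fits_cut m (shift_from G k H) k' hi (hi + k).
Proof. by cut_lia. Qed.

Lemma shift_fits_apart m G k H k' lo hi : apart G H (maxn k k') -> lo <= hi ->
  fits_cut m G k lo hi -> ~~ in_block G k lo hi -> fits_cut m H k' lo hi ->
  fits_cut m (shift_from G k H) k' (shift_from G k lo) (shift_from G k hi).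
Proof. by cut_lia. Qed.

Lemma shift_block_apart G k H k' j : apart G H (maxn k k') -> k' <= H -> j < k' ->
  [/\ ~~ in_block G k (H - k' + j) (H + j),
      shift_from G k (H - k' + j) = shift_from G k H - k' + j
    & shift_from G k (H + j) = shift_from G k H + j].
Proof. by cut_lia. Qed.

Section InsertBlock.
Variables (G k : nat).
Local Notation shift := (shift_from G k).

Definition block_step (x y : nat) : bool := in_block G k (minn x y) (maxn x y).

Fixpoint insert_block_from (x : nat) (s : seq nat) : seq nat :=
  match s with
  | [::] => [:: shift x]
  | y :: s' => shift x :: (if block_step x y then maxn x y :: insert_block_from y s'
                          else insert_block_from y s')
  end.

Definition insert_block (p : seq nat) : seq nat :=
  if p is x :: s then insert_block_from x s else [::].

(* A block edge {lo, hi} is routed through the new vertex hi, the old vertex hi having moved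
   to hi + k. *)
Definition split_edge (e : nat * nat) : seq (nat * nat) :=
  if in_block G k e.1 e.2 then [:: e; (e.2, e.2 + k)] else [:: (shift e.1, shift e.2)].

Lemma insert_block_from_head x s : exists r, insert_block_from x s = shift x :: r.
Proof. by case: s => [|y s] /=; eexists. Qed.

Lemma in_block_shift lo hi : lo <= hi -> in_block G k lo hi -> shift lo = lo /\ shift hi = hi + k.
Proof. by rewrite /in_block /shift_from; case: (ltnP lo G); case: (ltnP hi G); lia. Qed.

Lemma split_step_edges x y :
  perm_eq (if block_step x y then [:: sort_edge (shift x, maxn x y); sort_edge (maxn x y, shift y)]
           else [:: sort_edge (shift x, shift y)])
          (split_edge (sort_edge (x, y))).
Proof.
rewrite /block_step /split_edge /sort_edge /=.
have [le_xy|lt_yx] := leqP x y.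
  rewrite (minn_idPl (shift_from_mono _ _ le_xy)) (maxn_idPr (shift_from_mono _ _ le_xy)).
  case: ifP => // /(in_block_shift le_xy) [-> ->].
  rewrite (minn_idPl le_xy) (maxn_idPr le_xy).
  by rewrite (minn_idPl (leq_addr _ _)) (maxn_idPr (leq_addr _ _)).
have le_yx := ltnW lt_yx.
rewrite (minn_idPr (shift_from_mono _ _ le_yx)) (maxn_idPl (shift_from_mono _ _ le_yx)).
case: ifP => // /(in_block_shift le_yx) [-> ->].
rewrite (minn_idPr le_yx) (maxn_idPl le_yx) (minn_idPr (leq_addr _ _)) (maxn_idPl (leq_addr _ _)).
by rewrite (perm_catC [:: _] [:: _]).
Qed.

Lemma uedges_insert_block p :
  perm_eq (uedges (insert_block p)) (flatten (map split_edge (uedges p))).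
Proof.
case: p => // x s; elim: s x => [|y s IH] x //.
have [r Er] := insert_block_from_head y s.
rewrite uedges_cons2 /= -/(split_edge _).
have := split_step_edges x y; case: ifP => _ split_xy.
  by rewrite Er !uedges_cons2 -Er; exact: perm_cat split_xy (IH y).
by rewrite Er uedges_cons2 -Er; exact: perm_cat split_xy (IH y).
Qed.

Lemma insert_block_perm p :
  perm_eq (insert_block p) (map shift p ++ [seq e.2 | e <- uedges p & in_block G k e.1 e.2]).
Proof.
case: p => // x s; elim: s x => [|y s IH] x //.
rewrite uedges_cons2 /= -/(block_step x y) perm_cons; case: ifP => _; last exact: IH.
by apply/permP => P; rewrite /= (permP (IH y)) /= !count_cat /=; lia.
Qed.
End InsertBlock.

Definition block_at (m v : nat) (p : seq nat) (G k : nat) : bool :=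
  [&& 0 < k <= m, k <= G, G + k <= v,
      all (fun j => (G - k + j, G + j) \in uedges p) (iota 0 k)
    & all (fun e => fits_cut m G k e.1 e.2) (uedges p)].

Section InsertPath.
Variables (m v G k : nat) (p : seq nat).
Hypotheses (m2_le_v : m.*2 <= v) (p_ham : ham_path v p)
  (p_short : all (fun l => l <= m) (path_lengths v p)) (p_block : block_at m v p G k).

Local Notation q := (insert_block G k p).
Local Notation tops := [seq e.2 | e <- uedges p & in_block G k e.1 e.2].

Let k_gt0 : 0 < k. Proof. by case/and5P: p_block => /andP []. Qed.
Let k_le_m : k <= m. Proof. by case/and5P: p_block => /andP []. Qed.
Let k_le_G : k <= G. Proof. by case/and5P: p_block. Qed.
Let Gk_le_v : G + k <= v. Proof. by case/and5P: p_block. Qed.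

Let block_edge j : j < k -> (G - k + j, G + j) \in uedges p.
Proof. by case/and5P: p_block => _ _ _ /allP blk _ lt_jk; apply: blk; rewrite mem_iota. Qed.

Let mem_p x : (x \in p) = (x < v).
Proof. by rewrite (perm_mem p_ham) mem_iota. Qed.

Let uedge_le e : e \in uedges p -> e.1 <= e.2.
Proof. by case/mapP => e' _ ->; apply: sort_edge_le. Qed.

Let k2_le_v : k.*2 <= v.
Proof. by apply: leq_trans m2_le_v; rewrite leq_double. Qed.

Let uedge_len e : e \in uedges p -> edge_len v e.1 e.2 <= m.
Proof. by move=> e_p; apply: (allP p_short); rewrite path_lengthsE; apply: map_f. Qed.

Let uedge_fits e : e \in uedges p -> fits_cut m G k e.1 e.2.
Proof. by case/and5P: p_block => _ _ _ _ /allP; apply. Qed.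

Let mem_uedges_q e' :
  reflect (exists2 e, e \in uedges p & e' \in split_edge G k e) (e' \in uedges q).
Proof. by rewrite (perm_mem (uedges_insert_block G k p)); apply: flatten_mapP. Qed.

Lemma mem_block_tops z : (z \in tops) = (G <= z < G + k).
Proof.
apply/mapP/idP => [[e] | z_blk].
  by rewrite mem_filter /in_block => /andP [/andP [_ blk] _] ->.
exists (G - k + (z - G), G + (z - G)); last by rewrite /=; lia.
by rewrite mem_filter block_edge ?andbT /in_block /=; lia.
Qed.

Lemma block_tops_perm : perm_eq tops (iota G k).
Proof.
apply: uniq_perm; last by move=> z; rewrite mem_block_tops mem_iota.
  rewrite map_inj_in_uniq ?filter_uniq ?uniq_uedges ?(perm_uniq p_ham) ?iota_uniq //.
  move=> [lo hi] [lo' hi']; rewrite !mem_filter /in_block /=.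
  move=> /andP [blk e_p] /andP [blk' e'_p] eq_hi.
  by move: (uedge_le e_p) (uedge_le e'_p) blk blk'; rewrite /= -eq_hi => *; congr pair; lia.
exact: iota_uniq.
Qed.

Lemma count_block_edges : count (fun e => in_block G k e.1 e.2) (uedges p) = k.
Proof. by rewrite -size_filter -(size_map snd) (perm_size block_tops_perm) size_iota. Qed.

Lemma ham_path_insert_block : ham_path (v + k) q.
Proof.
apply: perm_trans (insert_block_perm G k p) _; apply: uniq_perm; first last.
- move=> z; rewrite mem_cat mem_block_tops mem_iota add0n; apply/orP/idP.
    case=> [/mapP [x x_p ->] | /andP [G_z z_Gk]]; last lia.
    by move: x_p; rewrite mem_p /shift_from; case: (ltnP x G); lia.
  move=> z_v; have [z_G | G_z] := ltnP z G.
    by left; apply/mapP; exists z; rewrite ?mem_p /shift_from ?z_G //; lia.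
  have [z_Gk | Gk_z] := ltnP z (G + k); first by right; apply/andP.
  left; apply/mapP; exists (z - k); rewrite ?mem_p /shift_from; first lia.
  by case: (ltnP (z - k) G); lia.
- exact: iota_uniq.
rewrite cat_uniq (map_inj_uniq (@shift_from_inj G k)) (perm_uniq p_ham) iota_uniq.
rewrite (perm_uniq block_tops_perm) iota_uniq andbT /=.
apply/hasPn => z; rewrite mem_block_tops => z_blk; apply/mapP => -[x _ z_x].
by move: z_blk; rewrite z_x /shift_from; case: (ltnP x G); lia.
Qed.

Lemma path_lengths_insert_block : perm_eq (path_lengths (v + k) q) (path_lengths v p ++ nseq k k).
Proof.
rewrite !path_lengthsE; apply: perm_trans (perm_map _ (uedges_insert_block G k p)) _.
rewrite map_flatten -map_comp.
set F := fun e => if in_block G k e.1 e.2 then [:: edge_len v e.1 e.2; k]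
                  else [:: edge_len v e.1 e.2].
suff /eq_in_map -> :
    {in uedges p, map (fun e => edge_len (v + k) e.1 e.2) \o split_edge G k =1 F}.
  have := flatten_map_if_perm (fun e => in_block G k e.1 e.2) (fun e => edge_len v e.1 e.2)
    k (uedges p).
  by rewrite count_block_edges.
move=> [lo hi] e_p; rewrite /F /split_edge /=; case: ifP => [blk | /negbT nblk] /=.
  by have [-> -> ->] := in_block_edge_len k2_le_v blk.
by rewrite (shift_edge_len m2_le_v (uedge_le e_p) (uedge_len e_p) (uedge_fits e_p) nblk).
Qed.

Lemma block_at_insert_block : block_at m (v + k) q (G + k) k.
Proof.
apply/and5P; split; rewrite ?k_gt0 ?k_le_m ?leq_addl ?leq_add2r //.
  apply/allP => j; rewrite mem_iota => /andP [_ lt_jk]; apply/mem_uedges_q.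
  exists (G - k + j, G + j); first exact: block_edge lt_jk.
  have blk : in_block G k (G - k + j) (G + j) by rewrite /in_block; lia.
  by rewrite /split_edge blk /= addnK addnAC !inE eqxx orbT.
apply/allP => e' /mem_uedges_q [[lo hi] e_p]; rewrite /split_edge /=.
case: ifP => [blk | /negbT nblk].
  have /andP [fit_lo fit_hi] := in_block_fits_next k_le_m blk.
  by rewrite !inE => /orP [] /eqP ->.
by rewrite inE => /eqP ->; apply: shift_fits_next (uedge_le e_p) (uedge_fits e_p) nblk.
Qed.

Lemma block_at_insert_block_apart H k' :
  apart G H (maxn k k') -> block_at m v p H k' -> block_at m (v + k) q (shift_from G k H) k'.
Proof.
move=> GH_apart /and5P [/andP [k'_gt0 k'_le_m] k'_le_H Hk'_le_v H_edges H_fits].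
apply/and5P; split; rewrite ?k'_gt0 ?k'_le_m //;
  try by move: GH_apart; rewrite /apart /shift_from; case: (ltnP H G); lia.
  apply/allP => j; rewrite mem_iota => /andP [_ lt_jk']; apply/mem_uedges_q.
  have e_p : (H - k' + j, H + j) \in uedges p by apply: (allP H_edges); rewrite mem_iota.
  have [nblk <- <-] := shift_block_apart (k := k) GH_apart k'_le_H lt_jk'.
  by exists (H - k' + j, H + j); rewrite // /split_edge /= (negbTE nblk) inE.
apply/allP => e' /mem_uedges_q [[lo hi] e_p]; rewrite /split_edge /=.
case: ifP => [blk | /negbT nblk].
  have /andP [fit_lo fit_hi] := in_block_fits_apart k_le_m GH_apart blk.
  by rewrite !inE => /orP [] /eqP ->.
rewrite inE => /eqP ->.
exact: shift_fits_apart GH_apart (uedge_le e_p) (uedge_fits e_p) nblk (allP H_fits _ e_p).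
Qed.
End InsertPath.

Definition shift_block (G k : nat) (B : nat * nat) : nat * nat := (shift_from G k B.1, B.2).

Definition blocks_at (m v : nat) (p : seq nat) (bs : seq (nat * nat)) : bool :=
  all (fun B => block_at m v p B.1 B.2) bs
  && all2rel (fun B C => (B == C) || apart B.1 C.1 (maxn B.2 C.2)) bs.

Lemma apart_shift G k H H' n :
  apart H H' n -> apart (shift_from G k H) (shift_from G k H') n.
Proof. by rewrite /apart /shift_from; case: (ltnP H G); case: (ltnP H' G); lia. Qed.

Lemma blocks_at_insert_block m v p bs G k :
  m.*2 <= v -> ham_path v p -> all (fun l => l <= m) (path_lengths v p) ->
  (G, k) \in bs -> blocks_at m v p bs ->
  blocks_at m (v + k) (insert_block G k p) (map (shift_block G k) bs).
Proof.
move=> m2_le_v p_ham p_short Gk_bs /andP [/allP bs_at /allrelP bs_apart].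
have p_block := bs_at _ Gk_bs; apply/andP; split.
  apply/allP => _ /mapP [[H k'] Hk'_bs ->] /=.
  case/orP: (bs_apart _ _ Gk_bs Hk'_bs) => [/eqP [<- <-] | GH_apart].
    by rewrite /shift_from ltnn; apply: block_at_insert_block.
  exact: block_at_insert_block_apart (bs_at _ Hk'_bs).
apply/allrelP => _ _ /mapP [B B_bs ->] /mapP [C C_bs ->].
by case/orP: (bs_apart _ _ B_bs C_bs) => [/eqP -> | /apart_shift ->]; rewrite ?eqxx ?orbT.
Qed.

Lemma count_adjacent_eq_undup (T : Type) (U : eqType) (f : T -> U) x s :
  count id (pairmap (fun y z => f y == f z) x s) + size (undup (map f (x :: s))) <= (size s).+1.
Proof.
elim: s x => [|y s IH] x //=; have := IH y; rewrite /=.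
case: ifP => fy_s; case: ifP => fx_ys; case: eqP => fx_fy /=; try lia.
all: by move: fx_ys; rewrite in_cons fx_fy eqxx.
Qed.

Lemma edge_len_dvd_eqmod v d x y :
  d %| v -> x < v -> y < v -> d %| edge_len v x y -> x = y %[mod d].
Proof.
move=> d_v x_v y_v; rewrite /edge_len; set D := maxn x y - minn x y.
have dvd_D : d %| D -> x = y %[mod d].
  by rewrite /D; case: leqP => [le_xy | /ltnW le_yx]; rewrite -eqn_mod_dvd // => /eqP.
have D_le_v : D <= v by rewrite /D; lia.
case: leqP => _ /= d_len; apply: dvd_D => //.
by rewrite -(subKn D_le_v); apply: dvdn_sub.
Qed.

Lemma count_dvd_path_lengths v d p :
  ham_path v p -> d %| v -> count (dvdn d) (path_lengths v p) <= v - d.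
Proof.
move=> p_ham d_v; have := perm_size p_ham; rewrite size_iota.
case: p p_ham => [|x s] p_ham; first by move=> <-.
move=> /= size_s; have mem_p z : (z \in x :: s) = (z < v) by rewrite (perm_mem p_ham) mem_iota.
have d_gt0 : 0 < d by case: d d_v => //; rewrite dvd0n => /eqP v0; rewrite v0 in size_s.
have same_residue : count (dvdn d) (pairmap (edge_len v) x s)
    <= count id (pairmap (fun y z => y %% d == z %% d) x s).
  have : all (fun z => z < v) (x :: s) by apply/allP => z; rewrite mem_p.
  elim: s {p_ham size_s mem_p} x => //= y s IH x /and3P [x_v y_v s_v].
  have := IH y; rewrite /= y_v s_v => /(_ isT).
  case: (boolP (d %| edge_len v x y)) => [/(edge_len_dvd_eqmod d_v x_v y_v) -> | _] /=; lia.
have all_residues : d <= size (undup (map (modn^~ d) (x :: s))).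
  rewrite -{1}[d](size_iota 0); apply: uniq_leq_size (iota_uniq 0 d) _ => i.
  rewrite mem_iota mem_undup => /andP [_ lt_id].
  apply/mapP; exists i; last by rewrite /= modn_small.
  by rewrite mem_p; apply: leq_trans (dvdn_leq _ d_v); lia.
have adjacent : count id (pairmap (fun y z => y %% d == z %% d) x s)
    + size (undup (map (modn^~ d) (x :: s))) <= (size s).+1.
  exact: count_adjacent_eq_undup.
rewrite /path_lengths; lia.
Qed.

Lemma L126_le6 a b c : all (fun l => l <= 6) (L126 a b c).
Proof. by rewrite /L126 !all_cat !all_nseq !orbT. Qed.

Lemma L126D a b c a' b' c' :
  perm_eq (L126 (a + a') (b + b') (c + c')) (L126 a b c ++ L126 a' b' c').
Proof. by apply/permP => P; rewrite /L126 !count_cat !count_nseq !mulnDr; lia. Qed.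

(* Blocks are needed exactly for the lengths that the induction still adds: a >= 10, b >= 12
   and c >= 15 are reduced to a - 1 >= 9, b - 2 >= 10 and c - 6 >= 9. *)
Definition block_widths (a b c : nat) : seq nat := mask [:: 9 <= a; 10 <= b; 9 <= c] [:: 1; 2; 6].

Definition realisable (a b c : nat) : Prop :=
  exists p bs, [/\ ham_path (a + b + c + 1) p,
                   perm_eq (path_lengths (a + b + c + 1) p) (L126 a b c),
                   blocks_at 6 (a + b + c + 1) p bs & map snd bs = block_widths a b c].

Lemma block_widths_grow a b c a' b' c' :
  (9 <= a + a') = (9 <= a) -> (10 <= b + b') = (10 <= b) -> (9 <= c + c') = (9 <= c) ->
  block_widths (a + a') (b + b') (c + c') = block_widths a b c.
Proof. by rewrite /block_widths => -> -> ->. Qed.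

Lemma realisable_grow a b c a' b' c' k :
  12 <= a + b + c + 1 -> L126 a' b' c' = nseq k k -> k \in block_widths a b c ->
  block_widths (a + a') (b + b') (c + c') = block_widths a b c ->
  realisable a b c -> realisable (a + a') (b + b') (c + c').
Proof.
move=> v_ge12 L_k k_wide widths_eq [p [bs [p_ham p_len p_blocks bs_widths]]].
set v := a + b + c + 1 in p_ham p_len p_blocks.
have [G Gk_bs] : exists G, (G, k) \in bs.
  by move: k_wide; rewrite -bs_widths => /mapP [[G k0] Gk0_bs /= ->]; exists G.
have m2_le_v : 6.*2 <= v by [].
have p_short : all (fun l => l <= 6) (path_lengths v p) by rewrite (perm_all _ p_len) L126_le6.
have p_block : block_at 6 v p G k by case/andP: p_blocks => /allP /(_ _ Gk_bs).
rewrite /realisable (_ : a + a' + (b + b') + (c + c') + 1 = v + k); last first.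
  by rewrite -(size_nseq k k) -L_k /v /L126 !size_cat !size_nseq; lia.
exists (insert_block G k p), (map (shift_block G k) bs); split.
- exact: ham_path_insert_block m2_le_v p_ham p_short p_block.
- apply: perm_trans (path_lengths_insert_block m2_le_v p_ham p_short p_block) _.
  by rewrite perm_sym -L_k; apply: perm_trans (L126D _ _ _ _ _ _) _; rewrite perm_cat2r perm_sym.
- exact: blocks_at_insert_block m2_le_v p_ham p_short Gk_bs p_blocks.
- by rewrite -map_comp widths_eq -bs_widths.
Qed.

(* The hypotheses of the theorem: once a >= 1, the divisor condition only restricts d = 6. *)
Definition admissible (a b c : nat) : bool :=
  (12 <= a + b + c + 1) && ((6 %| a + b + c + 1) ==> (5 <= a + b)).

Definition base_cases : seq ((nat * nat * nat) * (seq nat * seq (nat * nat))) := [::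
  ((1,1,10),([::5;11;12;6;0;7;1;8;2;4;10;3;9],[::(6,6)]));
  ((1,1,11),([::11;5;3;9;1;7;13;12;6;0;8;2;10;4],[::(7,6)]));
  ((1,1,12),([::6;12;3;9;0;13;7;1;10;4;5;11;2;8;14],[::(8,6)]));
  ((1,1,13),([::7;1;11;5;15;9;3;13;14;4;10;0;6;8;2;12],[::(6,6)]));
  ((1,1,14),([::6;12;10;4;15;9;3;14;8;2;13;7;1;0;11;5;16],[::(8,6)]));
  ((1,2,9),([::4;10;12;6;0;7;1;8;2;3;9;11;5],[::(6,6)]));
  ((1,2,10),([::3;9;1;7;13;11;5;4;10;12;6;0;8;2],[::(6,6)]));
  ((1,2,11),([::14;8;2;4;10;1;7;13;12;6;0;9;3;5;11],[::(6,6)]));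
  ((1,2,12),([::7;13;11;5;15;9;3;1;2;12;6;0;10;4;14;8],[::(10,6)]));
  ((1,2,13),([::11;5;3;9;15;4;10;16;14;8;2;13;7;1;0;6;12],[::(10,6)]));
  ((1,3,8),([::5;6;8;2;9;3;10;4;11;0;7;1;12],[::]));
  ((1,3,9),([::4;10;8;2;0;12;6;5;11;3;9;1;7;13],[::(7,6)]));
  ((1,3,10),([::12;6;8;14;0;9;3;5;11;2;4;10;1;7;13],[::(9,6)]));
  ((1,3,11),([::10;4;2;12;6;8;14;0;15;9;3;13;7;1;11;5],[::(9,6)]));
  ((1,3,12),([::14;16;10;4;15;0;6;12;1;7;13;2;8;9;3;5;11],[::(8,6)]));
  ((1,3,14),([::4;10;12;6;0;17;18;5;11;13;7;1;14;8;2;15;9;3;16],[::(7,6)]));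
  ((1,4,6),([::9;3;1;7;5;11;0;6;4;10;8;2],[::]));
  ((1,4,7),([::7;5;12;1;2;9;3;10;4;11;0;6;8],[::]));
  ((1,4,8),([::4;10;2;0;8;6;12;11;9;1;7;13;5;3],[::]));
  ((1,4,9),([::3;9;11;5;6;12;14;8;2;0;13;7;1;10;4],[::(8,6)]));
  ((1,4,10),([::5;11;13;7;1;3;9;15;14;12;6;0;10;4;2;8],[::(7,6)]));
  ((1,4,11),([::10;4;3;9;11;5;16;1;7;13;2;8;14;12;6;0;15],[::(6,6)]));
  ((1,4,12),([::9;3;15;13;7;1;17;11;5;4;10;16;14;8;2;0;12;6],[::(9,6)]));
  ((1,4,13),([::6;12;10;4;3;16;18;5;11;17;0;13;7;9;15;2;8;14;1],[::(10,6)]));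
  ((1,4,14),([::17;19;5;11;13;7;9;15;1;3;4;18;12;6;0;14;8;2;16;10],[::(11,6)]));
  ((1,5,5),([::1;7;9;3;5;11;0;6;8;10;4;2],[::]));
  ((1,5,6),([::11;9;2;0;6;8;7;1;12;5;3;10;4],[::]));
  ((1,5,7),([::3;1;9;7;13;5;11;12;6;4;2;10;8;0],[::]));
  ((1,5,8),([::6;8;14;5;7;9;3;12;11;2;0;13;4;10;1],[::]));
  ((1,5,9),([::5;11;1;15;9;3;13;7;8;14;0;2;4;10;12;6],[::(9,6)]));
  ((1,5,10),([::7;13;11;5;3;9;15;4;10;16;1;0;2;8;14;12;6],[::(8,6)]));
  ((1,5,11),([::13;7;1;3;9;11;5;17;15;16;10;4;2;8;14;12;6;0],[::(7,6)]));
  ((1,5,12),([::17;4;10;11;5;3;9;15;2;8;6;0;13;7;1;18;12;14;16],[::(6,6)]));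
  ((1,5,13),([::6;12;14;0;18;16;10;4;2;8;9;3;17;15;1;7;13;19;5;11],[::(8,6)]));
  ((1,5,14),([::11;5;3;9;10;4;2;8;14;20;18;12;6;0;15;17;19;13;7;1;16],[::(9,6)]));
  ((1,6,4),([::0;2;4;10;8;6;5;11;9;3;1;7],[::]));
  ((1,6,5),([::2;0;7;8;6;4;10;12;5;11;9;3;1],[::]));
  ((1,6,6),([::5;3;1;13;7;9;11;10;4;12;6;0;2;8],[::]));
  ((1,6,7),([::8;9;11;13;7;5;14;1;10;4;2;0;6;12;3],[::]));
  ((1,6,8),([::8;14;4;2;0;6;12;10;11;5;15;1;3;9;7;13],[::]));
  ((1,6,9),([::11;5;3;9;15;13;7;1;12;14;16;0;6;8;2;4;10],[::(6,6)]));
  ((1,6,10),([::9;15;17;11;5;3;1;13;7;8;14;16;10;4;2;0;12;6],[::(12,6)]));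
  ((1,6,11),([::9;3;4;10;12;6;0;17;11;5;7;13;15;2;8;14;1;18;16],[::(8,6)]));
  ((1,6,12),([::6;12;18;16;10;8;14;0;2;4;3;1;7;13;19;5;11;17;15;9],[::(13,6)]));
  ((1,6,13),([::9;15;17;11;12;18;3;5;20;14;8;6;4;10;16;1;7;13;19;0;2],[::(13,6)]));
  ((1,6,14),([::17;11;9;7;1;3;19;13;15;21;5;4;20;14;8;2;0;6;12;18;16;10],[::(16,6)]));
  ((1,7,3),([::3;1;11;9;7;5;4;10;0;6;8;2],[::]));
  ((1,7,4),([::9;11;12;10;3;5;7;1;8;6;0;2;4],[::]));
  ((1,7,5),([::7;9;3;11;5;13;1;2;4;6;0;12;10;8],[::]));
  ((1,7,6),([::2;4;3;5;7;13;11;9;0;6;12;10;1;14;8],[::]));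
  ((1,7,7),([::6;12;10;4;14;0;2;8;9;11;13;7;1;15;5;3],[::]));
  ((1,7,8),([::3;4;10;16;1;7;5;11;9;15;13;2;0;6;8;14;12],[::]));
  ((1,7,9),([::7;13;15;9;3;5;11;17;1;2;8;10;4;6;12;0;16;14],[::(8,6)]));
  ((1,7,10),([::0;17;4;2;15;9;3;1;7;13;11;5;6;12;14;8;10;16;18],[::(11,6)]));
  ((1,7,11),([::19;5;11;13;7;1;15;9;3;17;16;18;0;2;4;10;12;6;8;14],[::(9,6)]));
  ((1,7,12),([::3;18;12;6;5;20;14;8;10;16;1;7;9;15;17;11;13;19;0;2;4],[::(15,6)]));
  ((1,7,13),([::21;1;7;9;3;19;17;15;13;11;5;6;12;18;2;8;14;20;0;16;10;4],[::(7,6)]));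
  ((1,7,14),([::20;14;12;18;19;13;7;9;15;21;4;6;0;17;11;5;3;1;22;16;10;8;2],[::(15,6)]));
  ((1,8,2),([::6;0;10;8;2;4;3;5;7;9;11;1],[::]));
  ((1,8,3),([::9;2;4;10;8;6;0;11;12;1;3;5;7],[::]));
  ((1,8,4),([::2;8;6;0;12;10;4;5;3;1;13;7;9;11],[::]));
  ((1,8,5),([::0;9;11;2;1;3;5;7;13;4;6;8;14;12;10],[::]));
  ((1,8,6),([::0;6;4;2;12;14;8;10;9;3;1;7;5;11;13;15],[::]));
  ((1,8,7),([::0;1;7;5;16;14;3;9;11;13;15;4;6;12;10;8;2],[::]));
  ((1,8,8),([::17;11;5;7;9;3;15;13;1;0;6;4;2;8;10;16;14;12],[::]));
  ((1,8,9),([::0;2;8;14;16;10;9;15;13;7;5;3;1;18;12;6;4;17;11],[::(12,6)]));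
  ((1,8,10),([::19;13;11;17;3;5;7;1;15;9;8;14;16;10;12;18;0;6;4;2],[::(14,6)]));
  ((1,8,11),([::2;4;10;12;6;0;15;9;8;14;16;18;20;1;7;13;19;17;11;5;3],[::(10,6)]));
  ((1,8,12),([::9;15;17;11;5;7;13;19;3;1;21;20;18;12;10;16;0;6;4;2;8;14],[::(14,6)]));
  ((1,8,13),([::19;21;20;14;8;6;12;10;4;2;0;17;11;5;22;16;18;1;3;9;15;13;7],[::(10,6)]));
  ((1,8,14),([::21;23;1;7;13;11;5;3;9;15;17;19;18;12;6;0;2;8;14;20;22;16;10;4],[::(10,6)]));
  ((1,9,1),([::11;9;7;1;3;5;6;4;2;0;10;8],[::]));
  ((1,9,2),([::4;10;8;6;12;1;3;2;0;11;9;7;5],[::]));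
  ((1,9,3),([::5;3;1;9;11;13;7;8;6;4;10;12;0;2],[::]));
  ((1,9,4),([::14;12;11;9;3;5;7;1;10;8;6;4;13;0;2],[::]));
  ((1,9,5),([::11;13;3;5;15;9;7;1;2;4;6;8;10;0;14;12],[::]));
  ((1,9,6),([::7;13;15;9;11;12;14;8;6;0;2;4;10;16;1;3;5],[::]));
  ((1,9,7),([::7;5;3;1;13;11;17;15;9;8;10;16;0;12;6;4;2;14],[::]));
  ((1,9,8),([::12;10;11;13;15;9;3;16;18;5;7;1;14;8;6;4;17;0;2],[::]));
  ((1,9,9),([::1;19;5;11;13;7;9;15;17;3;2;4;10;12;6;0;18;16;14;8],[::(10,6)]));
  ((1,9,10),([::3;9;15;17;11;5;6;12;14;8;10;16;18;20;1;7;13;19;0;2;4],[::(12,6)]));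
  ((1,9,11),([::6;12;18;2;4;20;14;8;10;16;0;21;15;13;19;17;11;9;7;5;3;1],[::(16,6)]));
  ((1,9,12),([::3;9;11;5;4;10;8;2;19;17;15;13;7;1;18;16;22;20;14;12;6;0;21],[::(6,6)]));
  ((1,9,13),([::3;9;11;17;23;21;15;13;19;1;7;5;4;2;0;18;12;10;16;22;20;14;8;6],[::(16,6)]));
  ((1,9,14),([::16;10;4;23;21;19;18;12;6;0;2;8;14;20;22;24;1;7;13;11;5;3;9;15;17],[::(11,6)]));
  ((1,10,1),([::1;3;5;7;9;2;0;11;12;10;8;6;4],[::(9,2)]));
  ((1,10,2),([::6;0;2;4;12;10;8;9;11;13;1;3;5;7],[::(11,2)]));
  ((1,10,3),([::2;4;5;7;9;11;13;0;6;8;14;1;3;12;10],[::(7,2)]));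
  ((1,10,4),([::9;7;5;15;13;3;1;11;10;12;14;8;6;4;2;0],[::(8,2)]));
  ((1,10,5),([::7;5;16;10;12;6;4;2;0;15;13;11;9;8;14;3;1],[::(6,2)]));
  ((1,10,6),([::2;4;10;8;14;16;0;12;6;5;3;1;13;15;17;11;9;7],[::(4,2)]));
  ((1,10,7),([::9;7;5;18;0;13;11;17;15;2;4;6;12;10;8;14;16;3;1],[::(6,2)]));
  ((1,10,8),([::2;4;6;12;14;0;18;16;10;8;7;13;19;17;15;1;3;9;11;5],[::(3,2)]));
  ((1,10,9),([::2;0;15;17;19;13;7;8;14;12;6;4;10;16;18;20;1;3;9;11;5],[::(2,2);(9,6)]));
  ((1,10,10),([::5;11;13;7;1;3;9;15;17;19;21;20;18;16;14;8;2;0;6;12;10;4],[::(17,2);(10,6)]));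
  ((1,10,11),([::13;15;17;19;2;8;10;4;21;0;6;12;11;5;22;1;7;9;3;20;18;16;14],[::(17,2);(6,6)]));
  ((1,10,12),([::14;20;2;4;10;16;22;0;18;12;6;8;7;5;3;1;23;21;15;9;11;17;19;13],[::(3,2);(16,6)]));
  ((1,10,13),([::0;6;12;14;20;19;17;23;4;10;8;2;21;15;13;11;5;3;9;7;1;24;22;16;18],[::(14,2);(7,6)]));
  ((1,10,14),([::11;5;3;1;25;23;21;15;9;7;13;19;17;16;10;4;2;22;24;18;12;6;8;14;20;0],[::(3,2);(11,6)]));
  ((1,11,1),([::1;3;5;7;9;11;13;0;2;4;12;10;8;6],[::(10,2)]));
  ((1,11,2),([::4;2;0;14;12;6;8;10;1;3;5;7;9;11;13],[::(4,2)]));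
  ((1,11,3),([::6;4;2;12;14;0;10;8;9;11;13;15;1;7;5;3],[::(10,2)]));
  ((1,11,4),([::4;2;1;12;6;8;10;16;14;3;5;7;9;11;13;15;0],[::(4,2)]));
  ((1,11,5),([::6;4;16;14;12;10;8;2;0;17;15;13;1;7;5;3;9;11],[::(10,2)]));
  ((1,11,6),([::4;2;0;17;15;13;11;5;18;12;10;8;6;7;9;3;16;14;1],[::(12,2)]));
  ((1,11,7),([::3;5;11;17;15;9;7;13;19;1;0;14;16;18;12;10;8;6;4;2],[::(4,2)]));
  ((1,11,8),([::7;9;15;17;18;16;1;3;5;20;14;12;10;8;2;0;6;4;19;13;11],[::(9,2)]));
  ((1,11,9),([::2;0;20;18;16;10;4;6;12;14;8;7;13;15;9;3;1;21;19;17;11;5],[::(2,2);(9,6)]));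
  ((1,11,10),([::18;12;6;4;10;8;2;0;21;15;17;19;20;14;16;22;1;3;9;11;5;7;13],[::(2,2);(8,6)]));
  ((1,11,11),([::15;21;23;17;11;13;19;1;3;5;7;9;10;8;2;4;6;0;18;12;14;20;22;16],[::(9,2);(17,6)]));
  ((1,11,12),([::23;0;2;8;14;16;10;4;6;12;13;7;5;11;17;19;21;15;9;3;1;24;18;20;22],[::(2,2);(8,6)]));
  ((1,11,13),([::3;1;25;23;21;15;9;7;13;19;17;11;5;6;12;18;16;10;8;14;20;0;24;22;2;4],[::(3,2);(11,6)]));
  ((1,11,14),([::2;8;10;4;5;11;17;19;25;23;21;0;6;12;14;16;18;20;26;1;7;13;15;9;3;24;22],[::(19,2);(7,6)]));
  ((2,1,9),([::10;4;3;9;2;8;1;7;0;11;5;6;12],[::(7,6)]));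
  ((2,1,10),([::13;7;5;11;3;9;10;4;12;6;0;8;2;1],[::(8,6)]));
  ((2,1,11),([::5;11;12;6;0;9;3;2;8;14;1;7;13;4;10],[::(9,6)]));
  ((2,1,12),([::2;8;9;3;13;7;1;11;5;15;14;12;6;0;10;4],[::(6,6)]));
  ((2,1,13),([::13;7;6;12;1;2;0;11;5;16;10;4;15;9;3;14;8],[::(10,6)]));
  ((2,2,8),([::6;0;12;5;3;10;4;11;9;2;8;7;1],[::]));
  ((2,2,9),([::7;1;13;12;6;0;8;2;4;10;9;3;11;5],[::(7,6)]));
  ((2,2,10),([::8;14;13;7;5;11;2;1;10;4;6;12;3;9;0],[::(9,6)]));
  ((2,2,11),([::2;8;10;4;14;0;1;7;13;3;9;15;5;11;12;6],[::(8,6)]));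
  ((2,2,12),([::5;11;13;7;6;12;1;0;2;8;14;3;9;15;4;10;16],[::(10,6)]));
  ((2,2,14),([::11;5;4;10;16;3;9;15;2;0;13;7;1;14;8;6;12;18;17],[::(10,6)]));
  ((2,3,6),([::2;8;6;0;1;7;5;11;9;3;4;10],[::]));
  ((2,3,7),([::11;10;8;1;7;0;6;12;5;3;4;2;9],[::]));
  ((2,3,8),([::11;9;7;13;5;6;12;4;10;2;8;0;1;3],[::]));
  ((2,3,9),([::8;2;1;7;13;0;14;5;11;9;3;12;6;4;10],[::(7,6)]));
  ((2,3,10),([::11;5;6;12;2;4;10;0;14;8;7;13;3;9;15;1],[::(9,6)]));
  ((2,3,11),([::7;13;2;4;10;11;5;16;1;12;6;0;15;9;8;14;3],[::(10,6)]));
  ((2,3,12),([::0;6;12;10;4;16;15;9;3;5;11;17;1;7;13;14;8;2],[::(6,6)]));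
  ((2,3,13),([::10;4;2;8;9;3;16;14;15;17;11;5;18;12;6;0;13;7;1],[::(7,6)]));
  ((2,3,14),([::14;8;2;1;3;9;15;17;11;5;7;13;19;0;6;12;18;4;10;16],[::(13,6)]));
  ((2,4,5),([::1;0;6;4;10;8;2;3;9;11;5;7],[::]));
  ((2,4,6),([::4;6;12;10;9;2;3;5;11;0;7;1;8],[::]));
  ((2,4,7),([::11;3;9;10;4;12;6;8;2;0;1;13;7;5],[::]));
  ((2,4,8),([::13;4;3;12;6;5;14;8;10;1;7;9;11;2;0],[::]));
  ((2,4,9),([::13;3;9;8;2;4;10;12;14;0;6;7;1;11;5;15],[::(6,6)]));
  ((2,4,10),([::15;4;10;11;5;7;13;2;8;14;12;6;0;16;1;3;9],[::(8,6)]));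
  ((2,4,11),([::16;14;8;2;3;9;15;17;5;11;13;7;1;0;12;6;4;10],[::(8,6)]));
  ((2,4,12),([::16;10;8;14;12;6;7;13;0;2;15;9;3;4;17;11;5;18;1],[::(12,6)]));
  ((2,4,13),([::19;13;12;18;0;6;4;10;16;14;8;2;1;15;9;3;17;11;5;7],[::(14,6)]));
  ((2,4,14),([::7;13;14;8;6;12;10;4;19;0;15;9;3;18;16;1;2;17;11;5;20],[::(9,6)]));
  ((2,5,4),([::8;6;5;11;1;7;9;3;2;4;10;0],[::]));
  ((2,5,5),([::9;11;0;2;8;10;4;5;12;6;7;1;3],[::]));
  ((2,5,6),([::5;13;11;10;12;4;2;8;0;6;7;9;1;3],[::]));
  ((2,5,7),([::3;12;11;13;4;6;5;14;8;10;1;7;9;0;2],[::]));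
  ((2,5,8),([::12;14;4;2;8;6;7;9;3;13;15;5;11;1;0;10],[::]));
  ((2,5,9),([::3;9;8;2;1;16;14;12;6;0;11;5;7;13;15;4;10],[::(8,6)]));
  ((2,5,10),([::15;3;9;10;4;2;8;6;0;12;14;16;17;5;11;13;7;1],[::(6,6)]));
  ((2,5,11),([::1;14;8;6;12;13;7;5;11;17;0;2;15;9;3;4;10;16;18],[::(10,6)]));
  ((2,5,12),([::16;10;12;18;4;2;0;6;5;11;17;19;13;7;1;3;9;15;14;8],[::(13,6)]));
  ((2,5,13),([::1;2;8;10;4;19;0;6;12;14;20;5;11;17;16;18;3;9;15;13;7],[::(8,6)]));
  ((2,5,14),([::4;10;12;6;5;11;13;19;3;9;7;1;17;15;21;20;14;8;2;18;16;0],[::(7,6)]));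
  ((2,6,3),([::2;1;3;9;7;5;11;0;10;4;6;8],[::]));
  ((2,6,4),([::12;6;7;0;2;4;11;9;10;8;1;3;5],[::]));
  ((2,6,5),([::3;5;7;8;6;12;4;10;2;0;1;9;11;13],[::]));
  ((2,6,6),([::11;12;10;4;2;1;14;8;6;0;9;3;5;7;13],[::]));
  ((2,6,7),([::1;7;6;12;14;8;2;4;10;0;15;13;11;9;3;5],[::]));
  ((2,6,8),([::8;6;4;10;12;13;7;1;2;0;15;9;3;14;16;5;11],[::]));
  ((2,6,9),([::10;4;6;12;14;2;8;9;3;15;13;7;5;11;17;1;0;16],[::(8,6)]));
  ((2,6,10),([::14;8;2;0;18;1;3;9;15;13;7;5;11;17;16;10;4;6;12],[::(10,6)]));
  ((2,6,11),([::4;10;16;15;9;11;17;3;5;19;1;7;13;14;8;6;12;18;0;2],[::(13,6)]));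
  ((2,6,12),([::13;7;5;11;10;4;19;17;16;18;12;6;0;2;8;14;20;1;3;9;15],[::(8,6)]));
  ((2,6,13),([::20;4;2;3;9;15;17;11;5;21;19;13;7;1;0;6;8;14;16;10;12;18],[::(14,6)]));
  ((2,6,14),([::4;10;9;3;5;11;13;12;6;0;17;15;21;19;2;8;14;20;22;16;18;1;7],[::(7,6)]));
  ((2,7,2),([::2;3;9;7;5;11;1;0;10;8;6;4],[::]));
  ((2,7,3),([::9;2;0;12;10;8;6;4;3;1;7;5;11],[::]));
  ((2,7,4),([::6;5;11;9;3;1;13;7;8;10;4;2;0;12],[::]));
  ((2,7,5),([::7;9;11;10;8;14;5;3;12;6;4;13;0;2;1],[::]));
  ((2,7,6),([::13;12;2;0;6;8;14;4;10;11;9;15;1;3;5;7],[::]));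
  ((2,7,7),([::13;14;15;4;2;8;10;16;1;12;6;0;11;9;7;5;3],[::]));
  ((2,7,8),([::16;10;4;2;14;13;7;9;11;5;3;15;17;1;0;12;6;8],[::]));
  ((2,7,9),([::15;9;7;13;14;8;6;12;18;1;3;5;11;17;16;10;4;2;0],[::(13,6)]));
  ((2,7,10),([::5;11;12;6;4;10;16;18;0;14;8;2;3;9;7;1;19;13;15;17],[::(7,6)]));
  ((2,7,11),([::17;2;8;14;12;6;0;15;13;7;5;11;9;3;1;20;19;18;16;10;4],[::(8,6)]));
  ((2,7,12),([::21;19;13;7;5;11;17;1;3;9;10;4;6;12;14;8;2;18;20;0;16;15],[::(8,6)]));
  ((2,7,13),([::8;14;13;7;1;2;4;10;16;18;12;6;0;21;19;17;15;9;3;20;22;5;11],[::(11,6)]));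
  ((2,7,14),([::2;8;14;12;6;4;10;9;3;21;19;1;7;13;15;17;11;5;23;0;18;20;22;16],[::(9,6)]));
  ((2,8,1),([::9;10;8;6;4;2;0;11;1;7;5;3],[::]));
  ((2,8,2),([::10;4;3;5;7;9;11;0;2;1;12;6;8],[::]));
  ((2,8,3),([::0;6;7;5;3;1;13;11;9;10;8;2;4;12],[::]));
  ((2,8,4),([::0;9;8;14;1;3;5;7;13;11;10;12;6;4;2],[::]));
  ((2,8,5),([::9;7;8;10;4;2;12;6;0;14;15;13;11;1;3;5],[::]));
  ((2,8,6),([::11;9;7;5;6;12;1;16;14;3;4;10;8;2;13;15;0],[::]));
  ((2,8,7),([::12;13;1;3;15;9;11;17;5;7;6;8;14;16;0;2;4;10],[::]));
  ((2,8,8),([::7;13;0;2;15;14;16;3;1;18;5;11;9;8;10;12;6;4;17],[::]));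
  ((2,8,9),([::0;19;1;7;13;15;9;3;5;11;17;18;16;10;8;14;12;6;4;2],[::(12,6)]));
  ((2,8,10),([::3;9;8;2;17;19;4;10;12;14;16;18;20;5;11;13;15;0;6;7;1],[::(6,6)]));
  ((2,8,11),([::1;3;9;8;2;18;20;0;6;12;14;16;10;4;5;11;17;19;21;15;13;7],[::(8,6)]));
  ((2,8,12),([::22;0;21;15;13;19;2;8;6;4;10;16;17;11;5;7;9;3;1;18;12;14;20],[::(16,6)]));
  ((2,8,13),([::18;12;11;17;23;5;3;1;19;13;7;9;15;21;20;22;0;2;8;14;16;10;4;6],[::(13,6)]));
  ((2,8,14),([::2;8;14;20;19;21;23;17;15;13;7;5;11;9;3;1;0;6;12;18;24;22;16;10;4],[::(8,6)]));
  ((2,9,1),([::7;9;2;0;11;12;1;3;5;4;6;8;10],[::]));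
  ((2,9,2),([::7;8;0;12;10;2;4;6;5;3;1;13;11;9],[::]));
  ((2,9,3),([::12;10;8;2;3;4;6;0;13;11;9;7;5;14;1],[::]));
  ((2,9,4),([::13;15;5;3;1;7;9;8;6;4;2;12;14;0;10;11],[::]));
  ((2,9,5),([::13;14;3;2;0;11;9;7;5;16;1;12;10;8;6;4;15],[::]));
  ((2,9,6),([::14;12;6;4;10;11;13;15;3;5;17;1;7;9;8;2;0;16],[::]));
  ((2,9,7),([::12;13;7;1;14;8;6;4;2;0;17;15;9;11;10;16;18;5;3],[::]));
  ((2,9,8),([::4;3;9;11;5;19;17;15;1;7;13;14;16;18;12;10;8;6;0;2],[::]));
  ((2,9,9),([::10;16;18;12;6;0;19;13;11;17;15;9;7;5;4;2;3;1;20;14;8],[::(15,6)]));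
  ((2,9,10),([::16;10;9;15;17;11;13;19;21;5;7;1;3;4;6;12;18;20;0;2;8;14],[::(14,6)]));
  ((2,9,11),([::6;12;14;8;10;16;22;21;0;2;19;17;11;9;15;13;7;1;18;20;3;5;4],[::(12,6)]));
  ((2,9,12),([::21;15;13;19;17;11;9;7;5;6;12;18;0;2;8;14;20;22;16;10;4;3;1;23],[::(17,6)]));
  ((2,9,13),([::8;2;0;1;24;23;21;15;17;19;13;7;5;11;9;3;22;16;10;4;6;12;18;20;14],[::(8,6)]));
  ((2,9,14),([::22;16;18;17;23;3;1;25;5;11;13;7;9;15;21;19;20;14;8;2;4;10;12;6;0;24],[::(10,6)]));
  ((2,10,1),([::13;1;9;11;10;12;0;2;4;6;8;7;5;3],[::(4,2)]));
  ((2,10,2),([::9;7;8;14;12;10;1;3;5;6;4;2;0;13;11],[::(2,2)]));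
  ((2,10,3),([::13;15;14;12;10;8;6;4;2;0;1;7;5;11;9;3],[::(14,2)]));
  ((2,10,4),([::0;16;14;12;6;4;2;8;10;9;7;1;3;5;11;13;15],[::(14,2)]));
  ((2,10,5),([::17;11;9;3;5;4;2;0;6;8;10;12;14;16;15;13;1;7],[::(11,2)]));
  ((2,10,6),([::3;1;18;12;11;13;0;2;15;17;4;6;8;14;16;10;9;7;5],[::(6,2)]));
  ((2,10,7),([::2;4;10;16;15;17;3;5;7;9;11;13;19;1;0;18;12;6;8;14],[::(4,2)]));
  ((2,10,8),([::20;18;12;14;16;17;15;0;6;4;19;13;11;9;3;5;7;1;2;8;10],[::(10,2)]));
  ((2,10,9),([::11;17;1;21;15;9;7;6;8;10;16;18;12;14;20;0;2;4;5;3;19;13],[::(9,2);(16,6)]));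
  ((2,10,10),([::8;2;3;9;15;17;19;21;0;1;7;13;11;5;22;20;18;16;10;4;6;12;14],[::(19,2);(7,6)]));
  ((2,10,11),([::9;11;13;19;21;15;14;20;18;12;10;4;2;8;6;0;22;16;17;23;5;3;1;7],[::(12,2);(18,6)]));
  ((2,10,12),([::12;18;17;11;9;15;21;19;13;7;5;3;1;24;23;4;2;0;6;8;14;20;22;16;10],[::(7,2);(15,6)]));
  ((2,10,13),([::19;13;14;20;0;6;8;10;12;18;24;4;2;22;16;15;21;23;17;11;9;7;5;25;1;3],[::(10,2);(19,6)]));
  ((2,10,14),([::4;6;7;13;19;25;0;2;23;21;15;9;8;14;16;10;12;18;24;26;20;22;1;3;5;11;17],[::(5,2);(13,6)]));
  ((2,11,1),([::0;1;3;5;7;9;11;2;4;6;8;10;12;14;13],[::(10,2)]));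
  ((2,11,2),([::3;1;15;13;14;0;10;8;6;4;2;12;11;9;7;5],[::(8,2)]));
  ((2,11,3),([::2;0;16;1;3;14;12;10;4;6;8;9;7;5;11;13;15],[::(12,2)]));
  ((2,11,4),([::7;9;11;12;0;6;8;10;16;14;2;4;5;3;1;17;15;13],[::(9,2)]));
  ((2,11,5),([::13;15;17;4;2;1;7;9;11;5;3;16;14;12;10;8;6;0;18],[::(16,2)]));
  ((2,11,6),([::10;16;15;13;7;9;11;5;3;1;19;17;18;0;2;8;14;12;6;4],[::(2,2)]));
  ((2,11,7),([::6;5;7;8;10;16;14;12;18;20;1;3;9;11;17;2;4;19;0;15;13],[::(10,2)]));
  ((2,11,8),([::7;6;8;2;0;20;18;12;14;16;10;4;5;11;17;19;21;1;3;9;15;13],[::(19,2)]));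
  ((2,11,9),([::15;21;20;14;16;22;0;2;4;6;8;10;12;18;1;7;5;3;9;11;17;19;13],[::(11,2);(17,6)]));
  ((2,11,10),([::6;0;18;16;14;12;13;15;17;19;21;23;5;11;9;3;1;7;8;2;20;22;4;10],[::(17,2);(6,6)]));
  ((2,11,11),([::17;23;21;15;14;20;1;3;5;7;9;8;10;16;22;24;18;12;6;4;2;0;19;13;11],[::(2,2);(18,6)]));
  ((2,11,12),([::10;16;18;19;17;11;5;3;9;15;13;7;1;25;23;21;22;20;0;24;4;6;12;14;8;2],[::(18,2);(11,6)]));
  ((2,11,13),([::23;21;19;13;7;5;11;17;15;16;14;8;2;0;25;4;10;9;3;24;26;1;22;20;18;12;6],[::(22,2);(9,6)]));
  ((2,11,14),([::14;20;22;24;25;27;5;11;17;19;21;23;1;3;9;15;13;7;6;12;18;16;10;4;26;0;2;8],[::(22,2);(8,6)]));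
  ((3,1,8),([::10;4;5;12;11;0;6;7;1;8;2;9;3],[::]));
  ((3,1,9),([::10;4;3;9;1;7;8;2;0;6;12;11;5;13],[::(7,6)]));
  ((3,1,10),([::3;9;11;5;4;10;1;7;13;12;6;0;14;8;2],[::(6,6)]));
  ((3,1,11),([::6;12;13;7;1;11;5;15;14;8;2;0;10;4;3;9],[::(9,6)]));
  ((3,1,12),([::13;7;1;0;11;5;6;12;14;8;2;3;9;15;4;10;16],[::(10,6)]));
  ((3,1,14),([::9;15;13;7;8;14;1;0;6;12;18;5;11;17;4;10;16;3;2],[::(12,6)]));
  ((3,2,6),([::4;10;0;6;7;1;2;8;9;3;5;11],[::]));
  ((3,2,7),([::10;11;0;6;12;5;4;3;9;7;1;8;2],[::]));
  ((3,2,8),([::2;3;5;13;11;10;4;12;6;0;8;7;1;9],[::]));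
  ((3,2,9),([::12;6;7;13;14;8;2;0;9;3;1;10;4;5;11],[::(9,6)]));
  ((3,2,10),([::13;7;5;11;10;4;14;8;2;1;3;9;15;0;6;12],[::(9,6)]));
  ((3,2,11),([::15;9;3;5;11;10;4;2;8;14;13;7;1;12;6;0;16],[::(10,6)]));
  ((3,2,12),([::3;9;15;16;10;4;2;8;14;13;7;1;17;5;11;12;0;6],[::(6,6)]));
  ((3,2,13),([::18;16;10;9;15;2;8;14;1;7;13;0;6;12;11;5;3;4;17],[::(11,6)]));
  ((3,2,14),([::11;17;3;9;15;13;7;6;5;19;1;0;14;8;2;16;10;4;18;12],[::(13,6)]));
  ((3,3,5),([::4;5;11;10;8;2;0;6;7;1;3;9],[::]));
  ((3,3,6),([::7;5;3;10;11;4;2;9;8;1;0;6;12],[::]));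
  ((3,3,7),([::4;10;12;0;8;2;3;9;1;13;7;6;5;11],[::]));
  ((3,3,8),([::9;0;6;12;13;4;3;5;7;1;14;8;2;11;10],[::]));
  ((3,3,9),([::5;11;13;3;9;10;4;14;12;6;0;15;1;7;8;2],[::(7,6)]));
  ((3,3,10),([::11;5;3;9;7;1;16;0;6;12;13;2;8;14;15;4;10],[::(6,6)]));
  ((3,3,11),([::8;14;13;7;1;3;9;15;16;10;4;2;0;6;12;11;5;17],[::(10,6)]));
  ((3,3,12),([::10;16;14;8;9;15;17;11;5;18;12;6;0;13;7;1;2;4;3],[::(12,6)]));
  ((3,3,13),([::8;14;0;19;18;12;6;4;10;16;2;1;7;13;15;9;3;5;11;17],[::(11,6)]));
  ((3,3,14),([::14;8;2;1;3;18;12;6;4;10;16;17;11;5;20;0;15;9;7;13;19],[::(12,6)]));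
  ((3,4,4),([::6;0;10;11;5;3;4;2;8;9;7;1],[::]));
  ((3,4,5),([::7;9;8;1;2;4;3;10;12;5;11;0;6],[::]));
  ((3,4,6),([::3;9;8;7;1;13;11;5;6;12;0;2;10;4],[::]));
  ((3,4,7),([::4;5;6;0;9;3;1;10;12;14;8;7;13;11;2],[::]));
  ((3,4,8),([::1;11;10;12;14;0;6;4;5;15;9;3;13;7;8;2],[::]));
  ((3,4,9),([::16;10;9;15;4;3;5;11;13;7;1;0;2;8;14;12;6],[::(11,6)]));
  ((3,4,10),([::1;3;9;15;17;11;5;6;12;13;7;8;14;2;4;10;16;0],[::(10,6)]));
  ((3,4,11),([::1;0;17;15;2;4;10;16;3;9;11;5;18;12;6;7;13;14;8],[::(9,6)]));
  ((3,4,12),([::16;10;9;15;14;8;2;0;18;4;6;12;11;5;19;13;7;1;3;17],[::(11,6)]));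
  ((3,4,13),([::18;20;0;2;8;14;12;6;5;11;17;16;10;4;19;13;7;1;3;9;15],[::(10,6)]));
  ((3,4,14),([::10;4;3;9;11;5;21;20;18;2;8;14;12;6;0;16;15;17;1;7;13;19],[::(6,6)]));
  ((3,5,3),([::6;0;10;11;5;7;9;8;2;4;3;1],[::]));
  ((3,5,4),([::12;0;11;5;4;2;1;7;9;3;10;8;6],[::]));
  ((3,5,5),([::8;0;1;13;11;10;2;4;12;6;5;7;9;3],[::]));
  ((3,5,6),([::3;12;6;8;10;11;5;4;13;7;9;0;2;1;14],[::]));
  ((3,5,7),([::8;6;12;11;1;15;5;7;9;3;2;0;10;4;14;13],[::]));
  ((3,5,8),([::10;4;3;14;13;15;16;5;11;9;7;1;12;6;8;2;0],[::]));
  ((3,5,9),([::3;9;15;14;13;7;1;17;5;11;12;6;4;10;8;2;0;16],[::(7,6)]));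
  ((3,5,10),([::18;16;14;8;7;13;0;6;12;10;4;5;11;17;15;2;1;3;9],[::(9,6)]));
  ((3,5,11),([::8;14;12;6;5;11;17;3;9;15;16;10;4;2;0;18;19;1;7;13],[::(11,6)]));
  ((3,5,12),([::19;13;7;1;16;10;4;2;3;5;11;17;15;9;8;14;12;6;0;20;18],[::(10,6)]));
  ((3,5,13),([::7;13;14;8;9;15;17;11;5;3;19;21;1;2;18;20;4;10;16;0;6;12],[::(10,6)]));
  ((3,5,14),([::6;7;1;18;12;13;19;2;0;21;4;3;9;15;17;11;5;22;20;14;8;10;16],[::(15,6)]));
  ((3,6,2),([::6;7;8;2;0;10;4;5;3;1;11;9],[::]));
  ((3,6,3),([::4;11;10;3;5;7;9;8;6;12;1;0;2],[::]));
  ((3,6,4),([::11;10;9;7;5;13;1;3;4;2;8;0;12;6],[::]));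
  ((3,6,5),([::13;14;8;9;11;10;1;7;5;3;12;6;4;2;0],[::]));
  ((3,6,6),([::4;5;11;1;7;9;15;14;12;10;8;6;0;2;3;13],[::]));
  ((3,6,7),([::3;5;6;12;11;9;10;4;15;13;7;1;16;14;8;2;0],[::]));
  ((3,6,8),([::6;8;14;16;17;5;4;10;12;0;2;3;15;9;11;13;7;1],[::]));
  ((3,6,9),([::9;3;16;10;4;6;12;11;5;18;1;2;0;17;15;13;7;8;14],[::(9,6)]));
  ((3,6,10),([::15;9;3;4;10;12;6;8;14;0;18;16;17;11;5;7;13;19;1;2],[::(10,6)]));
  ((3,6,11),([::18;20;0;1;16;10;4;6;12;14;8;2;3;5;11;17;15;9;7;13;19],[::(10,6)]));
  ((3,6,12),([::21;15;9;8;2;18;12;10;16;0;20;14;13;19;17;11;5;7;1;3;4;6],[::(15,6)]));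
  ((3,6,13),([::4;10;9;3;5;11;12;14;16;22;21;15;17;0;6;8;2;19;13;7;1;18;20],[::(6,6)]));
  ((3,6,14),([::3;9;11;5;7;13;12;6;4;10;16;22;0;18;17;23;1;19;21;15;14;8;2;20],[::(9,6)]));
  ((3,7,1),([::0;1;11;9;10;8;2;4;6;7;5;3],[::]));
  ((3,7,2),([::6;7;0;2;4;10;8;9;11;12;1;3;5],[::]));
  ((3,7,3),([::4;5;13;11;3;9;7;6;8;10;12;0;2;1],[::]));
  ((3,7,4),([::2;1;7;9;0;14;13;11;5;3;12;10;8;6;4],[::]));
  ((3,7,5),([::3;2;4;10;8;9;11;5;7;13;15;1;0;6;12;14],[::]));
  ((3,7,6),([::8;14;13;7;6;0;2;4;15;9;11;12;10;16;1;3;5],[::]));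
  ((3,7,7),([::3;5;11;13;7;8;2;1;17;15;9;10;16;14;12;0;6;4],[::]));
  ((3,7,8),([::5;7;9;15;16;3;1;18;0;2;8;14;13;11;17;4;10;12;6],[::]));
  ((3,7,9),([::7;13;19;1;15;9;10;16;14;8;6;12;11;5;3;17;18;0;2;4],[::(11,6)]));
  ((3,7,10),([::20;14;8;9;15;16;10;12;18;17;11;5;3;1;7;13;19;0;2;4;6],[::(15,6)]));
  ((3,7,11),([::14;20;18;12;13;19;3;4;6;8;2;0;16;10;11;17;1;21;15;9;7;5],[::(16,6)]));
  ((3,7,12),([::14;20;21;19;13;12;18;16;10;8;2;4;6;0;22;5;11;17;15;9;3;1;7],[::(15,6)]));
  ((3,7,13),([::3;5;6;8;10;16;22;4;2;0;18;12;11;17;23;1;19;13;7;9;15;21;20;14],[::(16,6)]));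
  ((3,7,14),([::21;19;13;12;18;16;10;8;14;20;22;3;9;15;17;11;5;24;23;4;2;0;6;7;1],[::(15,6)]));
  ((3,8,1),([::9;10;4;2;0;11;12;1;3;5;7;8;6],[::]));
  ((3,8,2),([::6;4;3;9;7;8;10;12;0;2;1;13;11;5],[::]));
  ((3,8,3),([::0;9;7;8;14;1;3;5;6;4;2;11;13;12;10],[::]));
  ((3,8,4),([::5;3;13;14;15;9;7;1;11;12;10;8;6;4;2;0],[::]));
  ((3,8,5),([::1;12;14;16;0;2;13;11;10;4;6;8;7;5;3;9;15],[::]));
  ((3,8,6),([::5;4;16;17;15;3;9;11;13;1;7;6;8;10;12;14;2;0],[::]));
  ((3,8,7),([::17;4;5;3;2;15;9;11;10;12;14;16;18;1;7;13;0;6;8],[::]));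
  ((3,8,8),([::17;15;16;18;0;19;1;7;13;11;5;3;9;10;4;2;8;14;12;6],[::]));
  ((3,8,9),([::9;15;16;10;8;14;12;6;7;13;19;17;11;5;3;18;20;1;0;2;4],[::(11,6)]));
  ((3,8,10),([::18;20;0;1;7;13;15;9;3;2;8;10;4;6;12;14;16;17;11;5;21;19],[::(7,6)]));
  ((3,8,11),([::11;17;0;21;15;14;20;22;16;10;12;18;1;3;5;4;6;8;9;7;13;19;2],[::(17,6)]));
  ((3,8,12),([::2;4;10;12;6;5;11;13;7;1;19;20;18;0;22;16;14;8;9;15;17;23;21;3],[::(10,6)]));
  ((3,8,13),([::14;20;18;12;6;5;7;1;3;22;16;10;4;23;21;15;13;19;17;11;9;8;2;0;24],[::(17,6)]));
  ((3,8,14),([::7;13;19;20;14;12;18;24;22;21;23;3;1;25;5;11;17;15;9;8;2;0;6;4;10;16],[::(15,6)]));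
  ((3,9,1),([::12;4;2;0;13;1;3;5;7;6;8;10;9;11],[::]));
  ((3,9,2),([::14;1;0;6;8;2;4;3;5;7;9;11;13;12;10],[::]));
  ((3,9,3),([::6;4;2;12;11;1;15;13;14;0;10;8;9;7;5;3],[::]));
  ((3,9,4),([::1;12;6;5;7;9;3;4;2;0;15;13;11;10;8;14;16],[::]));
  ((3,9,5),([::7;13;11;9;3;1;0;2;4;16;10;12;14;15;17;5;6;8],[::]));
  ((3,9,6),([::9;15;14;16;10;8;2;0;18;1;3;5;7;13;11;12;6;4;17],[::]));
  ((3,9,7),([::16;15;14;8;6;4;2;0;18;12;10;9;11;5;19;17;3;1;7;13],[::]));
  ((3,9,8),([::11;17;15;16;14;12;18;19;13;7;1;20;5;3;9;10;8;6;0;2;4],[::]));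
  ((3,9,9),([::20;4;10;8;2;18;16;17;19;21;0;6;12;14;15;13;11;5;3;9;7;1],[::(6,6)]));
  ((3,9,10),([::19;13;14;20;22;16;10;4;2;0;21;15;9;11;17;18;12;6;8;7;5;3;1],[::(17,6)]));
  ((3,9,11),([::3;9;10;4;5;11;17;23;1;19;21;15;13;7;6;12;14;8;2;0;22;20;18;16],[::(9,6)]));
  ((3,9,12),([::4;6;12;14;8;7;13;15;9;10;16;18;19;21;2;0;23;17;11;5;24;1;20;22;3],[::(12,6)]));
  ((3,9,13),([::12;6;0;2;1;25;5;11;17;19;21;23;22;20;18;24;4;10;16;14;8;7;13;15;9;3],[::(9,6)]));
  ((3,9,14),([::19;21;20;14;8;10;16;18;12;6;0;1;3;9;15;13;7;5;11;17;23;2;4;25;26;24;22],[::(13,6)]));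
  ((3,10,1),([::3;1;7;9;11;13;14;12;10;8;6;5;4;2;0],[::(8,2)]));
  ((3,10,2),([::12;2;0;10;8;6;4;5;7;9;11;13;14;15;1;3],[::(8,2)]));
  ((3,10,3),([::5;11;13;12;10;4;2;0;15;14;16;1;3;9;7;6;8],[::(12,2)]));
  ((3,10,4),([::5;17;15;13;11;12;14;16;0;2;1;7;9;3;4;10;8;6],[::(13,2)]));
  ((3,10,5),([::12;10;9;11;13;15;17;18;5;3;16;14;1;7;8;6;0;2;4],[::(11,2)]));
  ((3,10,6),([::5;7;13;19;18;17;3;1;15;9;11;12;14;16;10;8;6;4;2;0],[::(6,2)]));
  ((3,10,7),([::6;4;19;17;15;13;14;8;7;9;11;5;3;18;12;10;16;1;20;0;2],[::(5,2)]));
  ((3,10,8),([::7;9;10;12;6;0;1;21;5;11;13;15;17;19;3;4;20;18;16;14;8;2],[::(19,2)]));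
  ((3,10,9),([::12;6;4;10;9;3;20;22;1;0;21;19;2;8;14;16;18;17;15;13;7;5;11],[::(17,2);(9,6)]));
  ((3,10,10),([::19;13;15;21;22;16;10;11;17;23;1;3;5;7;9;8;14;20;18;12;6;4;2;0],[::(2,2);(17,6)]));
  ((3,10,11),([::20;18;17;19;21;23;4;10;12;6;0;1;7;9;3;22;24;5;11;13;15;16;14;8;2],[::(19,2);(7,6)]));
  ((3,10,12),([::1;2;3;5;11;9;7;13;15;21;23;17;19;25;0;20;14;8;10;12;6;4;24;18;16;22],[::(5,2);(20,6)]));
  ((3,10,13),([::6;4;2;3;24;18;16;22;1;7;9;8;10;12;14;20;26;0;21;15;17;23;25;19;13;11;5],[::(13,2);(21,6)]));
  ((3,10,14),([::11;5;3;9;10;4;26;0;6;12;14;8;2;24;22;23;1;7;13;15;17;19;25;27;21;20;18;16],[::(18,2);(6,6)]));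
  ((3,11,1),([::9;7;6;8;10;12;11;13;15;1;3;5;4;14;0;2],[::(8,2)]));
  ((3,11,2),([::5;6;8;10;12;14;16;15;0;2;13;11;9;7;1;3;4],[::(10,2)]));
  ((3,11,3),([::10;9;7;5;6;8;14;12;0;16;4;2;3;1;17;15;13;11],[::(8,2)]));
  ((3,11,4),([::1;2;0;18;17;15;13;11;9;7;5;3;16;10;8;14;12;6;4],[::(5,2)]));
  ((3,11,5),([::17;16;14;12;10;8;6;4;3;1;15;9;11;5;7;13;19;18;0;2],[::(2,2)]));
  ((3,11,6),([::13;14;20;18;3;5;7;1;16;15;17;2;0;19;4;6;8;10;12;11;9],[::(11,2)]));
  ((3,11,7),([::6;4;5;7;8;14;20;18;12;10;16;0;2;3;19;21;1;17;15;13;11;9],[::(6,2)]));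
  ((3,11,8),([::2;19;18;17;15;9;11;13;7;5;4;21;0;6;8;10;12;14;20;3;1;22;16],[::(7,2)]));
  ((3,11,9),([::4;2;1;23;0;22;16;10;12;18;20;14;8;6;7;5;3;21;15;13;19;17;11;9],[::(4,2);(16,6)]));
  ((3,11,10),([::19;13;14;20;1;3;5;7;8;10;12;6;4;2;0;23;17;11;9;15;21;22;16;18;24],[::(3,2);(19,6)]));
  ((3,11,11),([::7;13;12;6;8;14;20;18;19;17;11;5;3;1;25;23;21;15;9;10;16;22;24;4;2;0],[::(23,2);(11,6)]));
  ((3,11,12),([::8;9;15;21;0;25;19;13;11;17;23;2;4;10;16;18;12;14;20;22;24;26;1;3;5;6;7],[::(3,2);(15,6)]));
  ((3,11,13),([::18;12;13;19;17;11;9;7;5;3;1;23;24;2;0;22;16;10;8;6;4;26;20;14;15;21;27;25],[::(5,2);(16,6)]));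
  ((3,11,14),([::23;22;28;1;3;5;11;17;18;24;26;20;21;15;9;7;13;19;25;27;0;2;4;10;16;14;8;6;12],[::(4,2);(11,6)]));
  ((4,1,6),([::7;1;2;8;6;0;11;5;4;10;9;3],[::]));
  ((4,1,7),([::9;3;1;2;8;7;0;6;5;12;11;4;10],[::]));
  ((4,1,8),([::0;8;10;4;5;13;7;6;12;11;3;9;1;2],[::]));
  ((4,1,9),([::3;9;0;1;7;8;2;11;5;14;13;12;6;4;10],[::(7,6)]));
  ((4,1,10),([::4;10;9;3;5;11;1;7;13;14;15;0;6;12;2;8],[::(8,6)]));
  ((4,1,11),([::9;3;14;15;16;10;4;5;11;13;2;8;7;1;12;6;0],[::(7,6)]));
  ((4,1,12),([::11;17;5;4;16;10;9;15;3;2;14;8;6;12;0;1;7;13],[::(12,6)]));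
  ((4,1,13),([::0;13;7;1;14;8;6;12;18;17;11;5;4;3;16;10;9;15;2],[::(13,6)]));
  ((4,1,14),([::5;11;13;7;1;2;8;14;15;9;3;17;16;10;4;18;12;6;0;19],[::(10,6)]));
  ((4,2,5),([::0;10;4;3;9;11;5;6;7;1;2;8],[::]));
  ((4,2,6),([::5;3;1;8;2;9;10;4;11;12;0;7;6],[::]));
  ((4,2,7),([::5;6;7;1;9;3;11;10;4;2;8;0;12;13],[::]));
  ((4,2,8),([::2;4;5;14;8;7;13;11;10;1;0;6;12;3;9],[::]));
  ((4,2,9),([::12;11;5;15;14;13;7;1;3;9;8;2;4;10;0;6],[::(6,6)]));
  ((4,2,10),([::11;5;16;10;8;14;13;7;9;15;4;3;2;1;12;6;0],[::(11,6)]));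
  ((4,2,11),([::4;10;16;17;11;9;15;3;5;6;12;0;1;13;7;8;14;2],[::(12,6)]));
  ((4,2,12),([::0;13;7;5;11;10;4;6;12;18;17;16;3;9;15;2;1;14;8],[::(10,6)]));
  ((4,2,13),([::12;6;4;10;16;17;11;5;19;18;0;14;13;7;1;15;9;3;2;8],[::(7,6)]));
  ((4,2,14),([::2;1;3;9;15;0;20;5;11;17;18;12;6;7;13;19;4;10;16;14;8],[::(13,6)]));
  ((4,3,4),([::7;1;11;0;10;4;5;6;8;2;3;9],[::]));
  ((4,3,5),([::0;12;1;8;10;3;2;9;7;6;5;11;4],[::]));
  ((4,3,6),([::2;4;12;13;7;8;6;0;1;9;3;5;11;10],[::]));
  ((4,3,7),([::3;12;6;4;5;7;9;0;1;10;11;2;8;14;13],[::]));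
  ((4,3,8),([::12;13;15;1;11;5;7;6;0;10;9;3;4;14;8;2],[::]));
  ((4,3,9),([::14;8;9;15;4;10;16;0;2;13;7;6;12;11;5;3;1],[::(11,6)]));
  ((4,3,10),([::9;15;16;0;12;6;4;10;11;5;17;1;13;7;8;14;2;3],[::(10,6)]));
  ((4,3,11),([::6;12;13;7;9;15;17;11;5;4;10;16;3;2;8;14;1;18;0],[::(11,6)]));
  ((4,3,12),([::15;16;14;8;2;1;7;13;12;6;0;18;4;10;9;3;17;19;5;11],[::(6,6)]));
  ((4,3,13),([::8;14;12;6;7;13;11;5;20;19;4;10;16;18;3;9;15;0;1;2;17],[::(9,6)]));
  ((4,3,14),([::17;1;3;5;11;12;6;7;13;19;18;2;0;16;10;4;20;14;8;9;15;21],[::(11,6)]));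
  ((4,4,3),([::10;4;3;5;11;1;0;2;8;9;7;6],[::]));
  ((4,4,4),([::2;1;7;0;11;9;3;4;5;6;12;10;8],[::]));
  ((4,4,5),([::8;0;13;5;4;10;12;6;7;9;11;3;1;2],[::]));
  ((4,4,6),([::14;5;7;6;0;2;11;12;13;4;10;8;9;3;1],[::]));
  ((4,4,7),([::8;9;15;14;4;2;3;5;11;13;7;1;0;10;12;6],[::]));
  ((4,4,8),([::16;0;1;12;10;9;11;5;3;14;8;2;13;7;6;4;15],[::]));
  ((4,4,9),([::0;6;12;10;4;5;11;13;7;1;2;3;9;15;17;16;14;8],[::(9,6)]));
  ((4,4,10),([::8;14;16;10;9;15;17;0;6;12;18;5;11;13;7;1;2;3;4],[::(11,6)]));
  ((4,4,11),([::2;8;14;0;19;17;15;9;3;1;7;13;12;6;5;11;10;4;18;16],[::(8,6)]));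
  ((4,4,12),([::14;8;7;13;11;5;3;9;10;4;19;20;18;12;6;0;15;17;2;1;16],[::(9,6)]));
  ((4,4,13),([::5;11;17;19;20;14;8;2;18;12;10;16;15;9;3;4;6;0;21;1;7;13],[::(13,6)]));
  ((4,4,14),([::20;18;12;6;0;2;8;14;15;9;3;1;7;13;19;17;16;22;21;4;10;11;5],[::(8,6)]));
  ((4,5,2),([::6;8;7;5;4;10;0;1;11;9;3;2],[::]));
  ((4,5,3),([::3;10;9;11;0;7;8;6;12;1;2;4;5],[::]));
  ((4,5,4),([::6;12;13;1;7;9;11;10;4;5;3;2;0;8],[::]));
  ((4,5,5),([::2;8;7;9;3;1;0;14;12;10;4;13;11;5;6],[::]));
  ((4,5,6),([::8;7;1;0;10;4;6;12;14;13;15;9;11;5;3;2],[::]));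
  ((4,5,7),([::3;1;0;15;14;13;2;8;7;9;11;5;16;10;4;6;12],[::]));
  ((4,5,8),([::13;14;15;3;2;4;16;10;12;0;6;8;7;1;17;5;11;9],[::]));
  ((4,5,9),([::5;11;17;18;16;15;14;12;6;4;10;9;3;1;7;13;0;2;8],[::(8,6)]));
  ((4,5,10),([::9;15;17;11;5;6;8;14;13;7;1;19;0;2;16;10;12;18;4;3],[::(13,6)]));
  ((4,5,11),([::12;18;19;13;7;5;20;1;2;17;11;10;16;14;8;6;4;3;9;15;0],[::(14,6)]));
  ((4,5,12),([::14;8;6;12;10;4;20;19;17;16;18;2;3;9;15;21;5;11;13;7;1;0],[::(10,6)]));
  ((4,5,13),([::12;6;0;22;16;10;8;14;20;18;1;2;3;5;4;21;15;9;7;13;19;17;11],[::(12,6)]));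
  ((4,5,14),([::9;15;21;20;2;1;23;22;4;10;16;18;0;6;12;14;8;7;13;19;17;11;5;3],[::(10,6)]));
  ((4,6,1),([::11;1;2;0;10;9;3;4;6;8;7;5],[::]));
  ((4,6,2),([::3;2;9;8;6;4;5;7;0;11;10;12;1],[::]));
  ((4,6,3),([::0;8;9;11;3;2;4;6;5;7;1;13;12;10],[::]));
  ((4,6,4),([::8;14;5;3;9;10;12;11;13;7;6;4;2;0;1],[::]));
  ((4,6,5),([::11;12;2;8;10;4;6;0;1;3;5;7;9;15;14;13],[::]));
  ((4,6,6),([::9;15;14;3;1;0;11;12;13;2;4;6;8;10;16;5;7],[::]));
  ((4,6,7),([::15;9;7;6;12;0;1;3;2;4;10;8;14;16;17;5;11;13],[::]));
  ((4,6,8),([::3;9;7;1;18;5;6;8;14;13;0;2;4;10;16;15;17;11;12],[::]));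
  ((4,6,9),([::12;6;5;11;10;4;2;1;7;13;15;9;3;17;19;0;18;16;14;8],[::(9,6)]));
  ((4,6,10),([::0;19;17;18;12;6;7;13;15;9;8;14;20;1;16;10;4;2;3;5;11],[::(10,6)]));
  ((4,6,11),([::10;16;17;11;9;8;14;20;18;12;6;4;2;3;19;13;15;21;5;7;1;0],[::(16,6)]));
  ((4,6,12),([::2;19;17;11;5;3;9;15;21;20;22;0;1;7;13;14;8;10;16;18;12;6;4],[::(12,6)]));
  ((4,6,13),([::0;6;12;13;7;8;14;15;9;3;5;11;17;23;1;19;21;22;4;2;20;18;16;10],[::(11,6)]));
  ((4,6,14),([::14;8;7;13;15;9;3;1;20;22;21;2;4;10;16;18;24;23;17;19;0;6;12;11;5],[::(10,6)]));
  ((4,7,1),([::10;12;5;6;8;7;9;11;0;1;3;4;2],[::]));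
  ((4,7,2),([::4;12;10;2;3;5;6;8;7;9;11;13;1;0],[::]));
  ((4,7,3),([::0;2;11;5;14;1;3;4;6;8;7;9;10;12;13],[::]));
  ((4,7,4),([::14;0;1;11;10;8;9;15;13;3;5;7;6;4;2;12],[::]));
  ((4,7,5),([::15;14;13;11;10;8;7;9;3;5;16;1;12;6;0;2;4],[::]));
  ((4,7,6),([::1;3;9;7;8;6;4;10;11;5;17;15;16;14;2;0;12;13],[::]));
  ((4,7,7),([::6;5;11;17;18;0;13;15;9;7;1;3;4;2;8;10;16;14;12],[::]));
  ((4,7,8),([::5;7;1;3;2;4;18;16;17;11;10;12;6;8;14;0;19;13;15;9],[::]));
  ((4,7,9),([::16;17;2;8;10;4;19;0;1;20;18;3;9;11;5;6;12;14;15;13;7],[::(8,6)]));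
  ((4,7,10),([::13;7;1;0;20;14;12;6;5;11;9;3;4;10;8;2;18;16;17;19;21;15],[::(8,6)]));
  ((4,7,11),([::6;4;21;15;14;20;18;12;10;16;22;5;7;13;19;17;11;9;8;2;3;1;0],[::(16,6)]));
  ((4,7,12),([::1;2;8;10;4;22;16;17;11;5;3;9;15;13;7;6;12;14;20;18;0;23;21;19],[::(8,6)]));
  ((4,7,13),([::8;2;21;15;17;16;10;4;5;11;9;3;1;20;18;24;22;23;0;19;13;7;6;12;14],[::(8,6)]));
  ((4,7,14),([::15;9;11;17;23;24;18;19;13;7;8;14;12;6;0;2;4;10;16;22;20;21;1;25;5;3],[::(12,6)]));
  ((4,8,1),([::12;6;7;9;8;10;11;13;1;3;5;4;2;0],[::]));
  ((4,8,2),([::12;13;11;2;0;14;1;7;9;10;8;6;4;5;3],[::]));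
  ((4,8,3),([::8;14;0;15;1;11;9;10;12;13;3;5;7;6;4;2],[::]));
  ((4,8,4),([::8;9;11;12;10;16;0;15;13;2;4;6;5;7;1;3;14],[::]));
  ((4,8,5),([::16;0;2;14;15;9;10;8;7;13;11;17;1;3;5;4;6;12],[::]));
  ((4,8,6),([::3;9;7;8;2;0;17;11;13;15;16;14;1;18;12;10;4;5;6],[::]));
  ((4,8,7),([::10;4;3;9;8;2;0;18;17;11;13;15;1;19;5;7;6;12;14;16],[::]));
  ((4,8,8),([::10;12;11;9;8;6;7;13;15;0;19;4;2;17;18;3;1;16;14;20;5],[::]));
  ((4,8,9),([::15;21;19;13;11;17;16;10;4;5;7;9;8;6;0;20;14;12;18;2;1;3],[::(16,6)]));
  ((4,8,10),([::17;11;5;22;21;20;3;9;7;1;0;2;8;10;4;6;12;14;16;18;19;13;15],[::(7,6)]));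
  ((4,8,11),([::4;10;11;5;6;12;14;8;2;0;1;7;13;15;9;3;21;19;17;23;22;20;18;16],[::(10,6)]));
  ((4,8,12),([::12;6;4;5;11;13;7;1;24;18;17;15;9;10;16;14;8;2;21;23;0;19;20;22;3],[::(11,6)]));
  ((4,8,13),([::25;0;24;4;3;23;17;11;5;7;13;15;9;10;16;14;8;6;12;18;20;22;2;1;21;19],[::(13,6)]));
  ((4,8,14),([::7;13;14;8;6;12;18;17;11;5;4;10;16;22;24;26;1;3;9;15;21;23;2;0;25;19;20],[::(12,6)]));
  ((4,9,1),([::14;12;11;5;7;9;10;8;6;4;3;1;2;0;13],[::]));
  ((4,9,2),([::10;12;6;8;2;0;1;3;4;5;7;9;11;13;15;14],[::]));
  ((4,9,3),([::12;14;13;11;9;3;2;4;6;8;10;16;15;0;1;7;5],[::]));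
  ((4,9,4),([::13;12;0;17;5;7;9;11;10;8;6;4;2;14;16;15;3;1],[::]));
  ((4,9,5),([::5;4;10;16;17;15;13;7;9;11;12;14;8;6;0;2;3;1;18],[::]));
  ((4,9,6),([::10;8;9;3;5;19;18;0;6;4;2;1;7;13;11;17;15;16;14;12],[::]));
  ((4,9,7),([::19;0;1;7;8;9;10;12;6;4;2;17;15;13;11;5;20;14;16;18;3],[::]));
  ((4,9,8),([::9;10;16;14;13;19;3;4;6;8;2;0;20;18;12;11;5;7;1;21;15;17],[::]));
  ((4,9,9),([::5;7;9;15;16;10;11;17;0;2;4;6;8;14;20;22;21;19;13;12;18;1;3],[::(14,6)]));
  ((4,9,10),([::4;5;11;12;6;8;14;15;9;7;13;19;17;23;1;3;21;22;0;2;20;18;16;10],[::(11,6)]));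
  ((4,9,11),([::15;14;8;2;21;19;13;11;5;4;10;12;6;0;23;24;1;7;9;3;22;20;18;16;17],[::(7,6)]));
  ((4,9,12),([::23;24;4;6;12;13;7;5;25;0;2;22;20;14;8;10;16;18;19;17;11;9;15;21;1;3],[::(12,6)]));
  ((4,9,13),([::19;17;15;21;22;20;14;8;2;0;6;12;13;11;5;3;9;7;1;26;25;4;10;16;18;24;23],[::(6,6)]));
  ((4,9,14),([::20;26;24;18;17;23;1;7;6;0;2;4;5;3;9;15;21;27;25;19;13;11;12;10;8;14;16;22],[::(22,6)]));
  ((4,10,1),([::5;7;6;8;10;12;13;15;14;0;2;4;3;1;11;9],[::(10,2)]));
  ((4,10,2),([::16;15;4;6;8;10;12;14;13;11;9;7;1;0;2;3;5],[::(13,2)]));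
  ((4,10,3),([::7;6;8;10;12;14;15;13;11;9;3;4;16;0;2;1;17;5],[::(14,2)]));
  ((4,10,4),([::2;0;1;14;15;17;4;6;8;9;7;5;3;16;18;12;10;11;13],[::(7,2)]));
  ((4,10,5),([::4;6;8;2;0;19;17;18;16;15;1;7;9;3;5;11;13;14;12;10],[::(13,2)]));
  ((4,10,6),([::9;8;6;12;13;7;5;3;18;20;1;16;14;15;17;11;10;4;2;0;19],[::(4,2)]));
  ((4,10,7),([::13;12;11;17;18;20;14;16;10;8;6;0;2;4;5;7;9;15;21;19;3;1],[::(7,2)]));
  ((4,10,8),([::17;11;13;12;10;16;22;20;18;1;3;9;15;14;8;7;5;6;4;2;19;21;0],[::(3,2)]));
  ((4,10,9),([::1;3;5;7;13;14;8;9;15;21;23;0;2;4;6;12;18;20;22;16;10;11;17;19],[::(2,2);(13,6)]));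
  ((4,10,10),([::18;16;14;8;6;12;10;4;2;0;19;20;21;22;24;23;17;11;5;7;13;15;9;3;1],[::(3,2);(9,6)]));
  ((4,10,11),([::7;8;10;12;11;9;3;23;17;15;21;19;13;14;20;22;16;18;24;4;2;0;6;5;25;1],[::(10,2);(19,6)]));
  ((4,10,12),([::19;13;11;5;7;9;10;16;22;20;14;8;6;12;18;24;26;25;0;1;3;4;2;23;17;15;21],[::(3,2);(18,6)]));
  ((4,10,13),([::20;19;13;11;17;15;9;8;14;16;10;4;2;0;6;12;18;24;26;27;5;7;1;3;25;23;21;22],[::(25,2);(14,6)]));
  ((4,10,14),([::27;25;23;17;11;5;4;2;0;6;12;13;7;8;14;20;22;24;1;28;26;3;9;15;21;19;18;16;10],[::(24,2);(11,6)]));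
  ((4,11,1),([::12;14;16;15;0;1;3;4;2;13;11;9;7;5;6;8;10],[::(3,2)]));
  ((4,11,2),([::8;10;16;17;15;14;13;11;9;7;5;3;1;0;2;4;6;12],[::(6,2)]));
  ((4,11,3),([::13;12;14;8;6;7;9;15;17;0;2;4;5;3;1;18;16;10;11],[::(8,2)]));
  ((4,11,4),([::10;9;15;16;18;0;2;4;5;3;1;19;17;11;13;7;6;8;14;12],[::(3,2)]));
  ((4,11,5),([::7;6;0;20;14;12;10;8;9;11;13;15;17;19;4;2;1;16;18;3;5],[::(11,2)]));
  ((4,11,6),([::5;3;2;18;16;15;21;1;0;20;4;6;8;14;12;10;11;9;7;13;19;17],[::(5,2)]));
  ((4,11,7),([::17;15;9;8;6;12;10;4;2;0;21;22;16;14;20;19;18;1;3;5;7;13;11],[::(3,2)]));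
  ((4,11,8),([::6;7;9;11;13;19;21;20;22;4;2;8;10;16;14;15;17;23;5;3;1;0;18;12],[::(9,2)]));
  ((4,11,9),([::9;15;13;7;6;4;2;1;24;0;23;21;19;17;11;12;18;20;14;8;10;16;22;3;5],[::(4,2);(13,6)]));
  ((4,11,10),([::8;2;3;9;7;1;0;6;12;14;20;22;16;18;24;25;23;21;19;17;15;13;11;5;4;10],[::(13,2);(7,6)]));
  ((4,11,11),([::11;5;4;3;24;22;20;18;12;6;0;2;8;14;16;10;9;15;13;7;1;26;25;23;21;19;17],[::(22,2);(11,6)]));
  ((4,11,12),([::10;16;15;9;7;13;14;8;6;4;5;27;25;3;1;23;21;19;17;11;12;18;20;26;24;2;0;22],[::(19,2);(13,6)]));
  ((4,11,13),([::14;20;21;15;13;7;8;10;4;2;1;3;9;11;5;28;26;24;18;16;22;23;17;19;25;27;0;6;12],[::(26,2);(20,6)]));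
  ((4,11,14),([::11;9;8;10;12;13;19;25;1;3;27;21;22;28;0;24;18;16;14;20;26;2;4;6;7;5;29;23;17;15],[::(10,2);(23,6)]));
  ((5,1,5),([::2;0;6;5;11;10;4;3;9;8;7;1],[::]));
  ((5,1,6),([::5;7;8;1;2;3;9;10;4;11;12;6;0],[::]));
  ((5,1,7),([::1;7;9;8;0;6;5;13;12;4;3;11;10;2],[::]));
  ((5,1,8),([::6;5;3;12;11;2;8;14;0;1;7;13;4;10;9],[::]));
  ((5,1,9),([::4;10;8;2;3;9;15;14;13;7;1;0;6;12;11;5],[::(7,6)]));
  ((5,1,10),([::5;11;12;6;7;13;15;9;3;14;8;2;1;0;16;10;4],[::(11,6)]));
  ((5,1,11),([::14;2;8;10;4;3;9;15;16;17;11;5;6;12;0;1;7;13],[::(7,6)]));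
  ((5,1,12),([::0;1;2;8;14;13;7;6;12;18;5;11;17;15;9;3;4;10;16],[::(8,6)]));
  ((5,1,13),([::7;6;0;18;12;13;19;5;11;17;16;10;4;3;9;15;1;2;8;14],[::(14,6)]));
  ((5,1,14),([::4;10;16;18;12;6;0;1;2;17;11;5;20;19;13;7;8;14;15;9;3],[::(12,6)]));
  ((5,2,4),([::9;8;10;4;3;2;1;7;5;11;0;6],[::]));
  ((5,2,5),([::2;9;3;5;12;0;1;8;7;6;4;10;11],[::]));
  ((5,2,6),([::3;9;1;7;8;10;2;4;5;11;12;13;0;6],[::]));
  ((5,2,7),([::11;5;7;9;8;14;0;6;12;13;4;10;1;2;3],[::]));
  ((5,2,8),([::4;5;7;9;15;14;8;2;1;11;10;0;6;12;13;3],[::]));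
  ((5,2,9),([::8;2;4;10;11;5;16;0;6;12;13;14;15;9;3;1;7],[::(6,6)]));
  ((5,2,10),([::0;16;10;4;3;15;9;8;14;2;1;17;5;11;12;6;7;13],[::(11,6)]));
  ((5,2,11),([::9;3;4;10;16;14;8;7;13;12;6;0;1;2;15;17;11;5;18],[::(9,6)]));
  ((5,2,12),([::14;0;2;8;10;4;3;9;15;16;17;11;5;6;12;18;19;13;7;1],[::(8,6)]));
  ((5,2,13),([::19;20;14;8;7;13;11;5;3;4;10;16;1;2;17;18;12;6;0;15;9],[::(10,6)]));
  ((5,2,14),([::15;9;8;14;20;18;17;1;7;13;19;3;2;4;10;16;0;21;5;11;12;6],[::(10,6)]));
  ((5,3,3),([::5;4;2;3;9;11;10;8;7;1;0;6],[::]));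
  ((5,3,4),([::12;6;8;2;0;1;7;5;4;3;9;10;11],[::]));
  ((5,3,5),([::10;11;5;13;12;4;3;9;7;6;8;0;2;1],[::]));
  ((5,3,6),([::14;0;6;5;11;12;10;8;9;3;2;4;13;7;1],[::]));
  ((5,3,7),([::1;2;0;14;12;6;7;13;3;4;10;11;5;15;9;8],[::]));
  ((5,3,8),([::5;3;1;0;16;14;8;2;13;7;6;12;11;10;4;15;9],[::]));
  ((5,3,9),([::11;5;3;9;7;1;2;8;14;15;13;12;6;0;17;16;10;4],[::(6,6)]));
  ((5,3,10),([::13;7;8;14;1;2;15;17;16;3;9;11;5;4;10;12;6;0;18],[::(9,6)]));
  ((5,3,11),([::9;3;1;15;16;10;4;6;12;13;7;5;11;17;18;19;0;14;8;2],[::(9,6)]));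
  ((5,3,12),([::0;15;16;14;12;6;4;10;9;3;18;17;11;5;20;19;13;7;1;2;8],[::(7,6)]));
  ((5,3,13),([::0;21;15;9;8;14;20;18;12;6;7;13;19;3;1;2;4;10;16;17;11;5],[::(16,6)]));
  ((5,3,14),([::9;3;5;11;13;14;20;19;2;8;7;1;18;17;0;6;12;10;4;21;15;16;22],[::(6,6)]));
  ((5,4,2),([::2;8;10;4;5;6;7;9;11;0;1;3],[::]));
  ((5,4,3),([::2;8;6;7;0;12;11;9;10;4;5;3;1],[::]));
  ((5,4,4),([::10;4;12;0;6;7;8;9;11;13;5;3;2;1],[::]));
  ((5,4,5),([::8;10;11;9;3;4;13;7;1;2;0;14;12;6;5],[::]));
  ((5,4,6),([::14;0;2;8;7;6;4;10;9;15;5;3;13;12;11;1],[::]));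
  ((5,4,7),([::5;11;12;10;9;7;13;15;4;3;14;8;2;1;16;0;6],[::]));
  ((5,4,8),([::0;17;1;2;14;12;6;8;9;15;3;4;16;10;11;5;7;13],[::]));
  ((5,4,9),([::13;0;1;7;9;3;4;10;8;2;15;14;16;18;17;11;5;6;12],[::(7,6)]));
  ((5,4,10),([::1;7;13;14;0;19;17;15;16;2;8;9;3;5;11;10;4;6;12;18],[::(8,6)]));
  ((5,4,11),([::5;11;17;19;13;7;8;14;20;1;0;15;9;10;16;18;12;6;4;3;2],[::(13,6)]));
  ((5,4,12),([::11;5;3;19;17;1;0;21;20;14;8;9;15;13;7;6;12;18;2;4;10;16],[::(10,6)]));
  ((5,4,13),([::0;6;12;13;11;5;4;10;16;22;1;7;9;3;20;21;15;17;18;19;2;8;14],[::(6,6)]));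
  ((5,4,14),([::0;1;7;8;2;20;14;15;13;19;18;16;22;4;10;12;6;5;11;17;23;21;3;9],[::(7,6)]));
  ((5,5,1),([::10;0;2;3;1;11;5;4;6;7;8;9],[::]));
  ((5,5,2),([::9;11;4;10;12;1;0;2;3;5;6;7;8],[::]));
  ((5,5,3),([::8;10;4;5;3;2;1;9;11;13;12;0;6;7],[::]));
  ((5,5,4),([::3;2;8;6;5;7;1;0;9;11;10;12;14;13;4],[::]));
  ((5,5,5),([::9;8;7;13;3;5;15;0;6;4;2;1;11;10;12;14],[::]));
  ((5,5,6),([::0;1;12;6;7;8;14;16;15;13;2;4;10;11;9;3;5],[::]));
  ((5,5,7),([::13;7;9;8;10;4;6;5;11;17;16;15;3;1;2;14;12;0],[::]));
  ((5,5,8),([::17;15;13;11;10;9;3;4;5;18;12;6;0;2;8;7;1;14;16],[::]));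
  ((5,5,9),([::5;11;12;18;4;10;8;2;3;9;7;1;15;13;14;16;17;19;0;6],[::(6,6)]));
  ((5,5,10),([::18;12;11;17;15;9;7;13;19;20;1;0;6;5;3;2;8;14;16;10;4],[::(13,6)]));
  ((5,5,11),([::11;17;18;12;10;16;0;20;14;13;19;21;15;9;3;5;4;6;7;1;2;8],[::(16,6)]));
  ((5,5,12),([::10;16;22;1;0;17;11;12;18;20;14;8;9;15;21;4;6;7;5;3;2;19;13],[::(14,6)]));
  ((5,5,13),([::10;16;18;12;6;7;9;15;21;23;17;11;5;3;4;22;0;1;2;8;14;20;19;13],[::(14,6)]));
  ((5,5,14),([::22;3;9;11;5;7;13;15;16;17;19;18;24;23;4;10;12;6;0;1;20;14;8;2;21],[::(9,6)]));
  ((5,6,1),([::4;11;10;12;1;0;2;3;5;6;8;9;7],[::]));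
  ((5,6,2),([::5;7;8;6;4;10;9;3;2;0;1;13;11;12],[::]));
  ((5,6,3),([::1;7;8;6;5;3;2;11;9;10;12;14;0;13;4],[::]));
  ((5,6,4),([::0;1;7;8;2;3;9;11;13;15;14;12;10;4;6;5],[::]));
  ((5,6,5),([::6;7;1;16;14;3;4;5;11;12;10;8;9;15;0;2;13],[::]));
  ((5,6,6),([::9;8;6;4;3;2;0;12;11;17;5;7;1;13;15;14;16;10],[::]));
  ((5,6,7),([::16;3;1;2;15;14;12;10;8;9;11;17;4;6;5;18;0;13;7],[::]));
  ((5,6,8),([::18;19;17;3;1;0;14;15;16;10;4;2;8;6;12;13;7;5;11;9],[::]));
  ((5,6,9),([::3;9;10;4;2;1;16;14;8;6;12;18;17;19;20;0;15;13;7;5;11],[::(9,6)]));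
  ((5,6,10),([::5;11;17;18;12;6;4;3;2;1;21;19;13;7;9;15;16;10;8;14;20;0],[::(11,6)]));
  ((5,6,11),([::5;11;9;3;4;10;8;2;19;13;7;1;18;17;15;16;14;12;6;0;22;20;21],[::(8,6)]));
  ((5,6,12),([::7;13;12;6;0;2;1;19;20;18;16;10;4;22;23;21;3;5;11;17;15;9;8;14],[::(12,6)]));
  ((5,6,13),([::11;13;19;20;14;16;22;24;18;17;23;0;1;7;8;2;21;15;9;3;5;4;10;12;6],[::(19,6)]));
  ((5,6,14),([::22;16;10;9;15;14;8;6;12;18;17;11;5;25;23;3;1;2;4;24;0;20;21;19;13;7],[::(11,6)]));
  ((5,7,1),([::12;6;5;3;4;2;0;1;13;11;10;8;9;7],[::]));
  ((5,7,2),([::3;5;11;2;4;6;7;8;9;10;12;14;1;0;13],[::]));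
  ((5,7,3),([::8;9;3;5;7;13;11;10;12;14;15;0;6;4;2;1],[::]));
  ((5,7,4),([::7;5;6;0;15;13;11;12;14;16;1;2;8;9;3;4;10],[::]));
  ((5,7,5),([::5;3;1;17;11;12;10;4;6;7;13;14;15;9;8;2;0;16],[::]));
  ((5,7,6),([::10;4;17;0;13;11;9;15;16;14;12;18;1;3;2;8;7;6;5],[::]));
  ((5,7,7),([::19;13;15;1;0;14;16;18;4;3;17;11;12;10;9;7;5;6;8;2],[::]));
  ((5,7,8),([::15;13;19;20;14;16;1;0;6;7;8;10;12;18;3;5;4;2;17;11;9],[::]));
  ((5,7,9),([::10;4;2;8;14;16;0;6;12;13;11;5;3;9;7;1;21;20;19;18;17;15],[::(7,6)]));
  ((5,7,10),([::10;4;2;0;6;12;13;7;9;15;16;22;1;3;5;11;17;18;19;21;20;14;8],[::(10,6)]));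
  ((5,7,11),([::5;11;9;3;2;8;14;15;16;17;23;21;19;13;7;1;0;22;20;18;12;6;4;10],[::(8,6)]));
  ((5,7,12),([::12;18;19;13;14;20;1;3;4;10;16;22;24;5;6;8;7;9;11;17;23;0;2;21;15],[::(17,6)]));
  ((5,7,13),([::2;1;7;13;19;17;11;10;16;14;8;9;15;21;22;24;0;20;18;12;6;4;5;25;23;3],[::(13,6)]));
  ((5,7,14),([::13;7;8;14;16;10;4;5;6;12;18;24;23;17;11;9;15;21;19;25;0;2;3;1;22;20;26],[::(12,6)]));
  ((5,8,1),([::6;7;9;10;12;11;13;0;14;1;3;5;4;2;8],[::]));
  ((5,8,2),([::10;4;5;3;1;15;13;14;0;2;12;11;9;8;6;7],[::]));
  ((5,8,3),([::6;0;11;5;4;2;3;1;16;15;13;14;12;10;8;9;7],[::]));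
  ((5,8,4),([::7;13;11;12;6;5;4;2;0;16;15;17;1;3;9;10;8;14],[::]));
  ((5,8,5),([::0;17;4;6;7;13;11;9;10;8;2;1;3;5;18;12;14;15;16],[::]));
  ((5,8,6),([::2;0;18;12;14;15;13;7;9;8;6;5;19;1;3;4;10;16;17;11],[::]));
  ((5,8,7),([::3;1;7;9;11;17;19;20;0;15;13;14;8;2;4;5;6;12;10;16;18],[::]));
  ((5,8,8),([::10;12;13;15;14;8;9;3;2;4;6;0;16;18;20;19;17;11;5;21;1;7],[::]));
  ((5,8,9),([::7;5;22;20;14;13;19;18;12;6;8;10;16;17;11;9;15;21;0;2;1;3;4],[::(16,6)]));
  ((5,8,10),([::6;5;11;17;16;10;4;2;0;22;23;1;3;9;7;8;14;20;18;12;13;19;21;15],[::(16,6)]));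
  ((5,8,11),([::5;11;17;19;20;21;23;22;3;9;7;1;24;18;12;14;13;15;16;10;4;2;8;6;0],[::(6,6)]));
  ((5,8,12),([::24;4;10;11;5;6;12;13;15;14;8;2;0;20;18;16;22;21;19;17;23;3;9;7;1;25],[::(7,6)]));
  ((5,8,13),([::14;20;22;16;10;8;7;1;2;23;24;18;12;6;4;5;3;9;15;17;11;13;19;21;0;25;26],[::(15,6)]));
  ((5,8,14),([::17;23;1;7;13;11;5;4;10;8;2;0;26;27;25;3;9;15;16;22;24;18;19;21;20;14;12;6],[::(7,6)]));
  ((5,9,1),([::1;0;2;8;10;12;14;15;13;11;9;7;6;5;3;4],[::]));
  ((5,9,2),([::16;5;11;12;14;13;15;0;2;1;3;4;6;8;10;9;7],[::]));
  ((5,9,3),([::12;6;7;5;4;2;3;9;10;8;14;16;0;1;17;15;13;11],[::]));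
  ((5,9,4),([::8;9;11;13;0;6;7;1;18;17;15;16;14;12;10;4;2;3;5],[::]));
  ((5,9,5),([::9;8;2;0;18;4;5;19;1;3;17;15;16;14;12;10;11;13;7;6],[::]));
  ((5,9,6),([::13;15;14;20;18;19;17;2;8;10;16;1;0;6;4;3;5;7;9;11;12],[::]));
  ((5,9,7),([::6;12;13;11;5;21;1;3;2;4;10;9;15;17;19;18;20;0;16;14;8;7],[::]));
  ((5,9,8),([::7;5;3;20;19;18;12;6;4;21;15;17;11;13;14;16;22;1;0;2;8;10;9],[::]));
  ((5,9,9),([::0;6;5;7;13;19;17;11;10;16;18;12;14;20;22;21;23;1;3;4;2;8;9;15],[::(15,6)]));
  ((5,9,10),([::23;21;22;24;5;3;9;15;17;11;13;19;0;1;2;4;6;7;8;14;20;18;12;10;16],[::(14,6)]));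
  ((5,9,11),([::7;13;14;8;2;0;1;3;9;10;4;6;12;11;5;25;23;21;15;17;19;20;18;24;22;16],[::(9,6)]));
  ((5,9,12),([::26;24;18;12;13;19;17;11;5;7;6;0;1;3;9;15;16;10;8;14;20;22;21;23;25;4;2],[::(14,6)]));
  ((5,9,13),([::11;5;27;1;3;9;8;2;24;18;16;17;19;25;23;21;20;14;15;13;7;6;12;10;4;26;0;22],[::(8,6)]));
  ((5,9,14),([::1;0;2;8;14;12;6;7;13;19;25;24;22;28;26;20;18;16;10;9;15;17;11;5;3;4;27;21;23],[::(12,6)]));
  ((5,10,1),([::14;13;15;16;5;3;1;0;2;4;6;7;9;11;12;10;8],[::(9,2)]));
  ((5,10,2),([::0;2;14;12;10;9;11;13;15;16;17;5;7;8;6;4;3;1],[::(11,2)]));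
  ((5,10,3),([::9;11;10;12;14;16;17;18;0;1;3;5;7;13;15;2;8;6;4],[::(14,2)]));
  ((5,10,4),([::3;17;15;9;10;12;13;11;5;7;6;4;2;0;1;19;18;16;14;8],[::(16,2)]));
  ((5,10,5),([::17;19;20;5;7;8;6;0;2;4;3;1;16;10;9;11;13;15;14;12;18],[::(7,2)]));
  ((5,10,6),([::10;8;9;11;12;14;15;13;7;6;4;2;18;16;0;20;21;5;3;19;17;1],[::(14,2)]));
  ((5,10,7),([::1;0;21;15;13;12;14;16;22;20;18;17;19;2;8;10;4;3;9;11;5;7;6],[::(14,2)]));
  ((5,10,8),([::22;23;17;11;12;18;20;14;16;10;8;2;0;1;3;4;6;5;7;9;15;13;19;21],[::(2,2)]));
  ((5,10,9),([::2;3;1;7;13;12;6;0;24;22;20;18;16;10;8;14;15;9;11;17;19;21;23;4;5],[::(20,2);(12,6)]));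
  ((5,10,10),([::13;19;18;12;14;20;22;24;4;10;16;17;11;5;6;8;7;9;15;21;23;25;1;3;2;0],[::(23,2);(16,6)]));
  ((5,10,11),([::21;15;16;22;24;18;17;23;2;4;10;8;7;9;11;13;19;25;0;1;26;20;14;12;6;5;3],[::(4,2);(19,6)]));
  ((5,10,12),([::15;13;7;6;12;10;4;2;8;14;16;17;19;21;23;1;0;22;24;25;3;9;11;5;27;26;20;18],[::(20,2);(9,6)]));
  ((5,10,13),([::1;2;4;10;8;7;9;3;26;20;21;27;28;5;11;13;15;17;23;25;19;18;24;22;16;14;12;6;0],[::(14,2);(22,6)]));
  ((5,10,14),([::17;23;25;27;28;29;0;2;3;1;7;5;11;13;19;21;15;9;8;14;20;22;16;10;4;6;12;18;24;26],[::(25,2);(18,6)]));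
  ((5,11,1),([::10;12;14;15;17;16;0;2;3;1;13;11;9;8;6;4;5;7],[::(6,2)]));
  ((5,11,2),([::12;14;16;10;8;9;7;6;4;3;5;11;13;15;17;0;18;1;2],[::(5,2)]));
  ((5,11,3),([::12;18;4;2;3;5;7;9;11;10;8;6;0;1;19;17;16;14;13;15],[::(7,2)]));
  ((5,11,4),([::19;4;5;7;1;20;0;2;3;18;16;17;15;13;11;9;10;8;6;12;14],[::(13,2)]));
  ((5,11,5),([::19;21;20;14;12;18;17;1;3;4;2;0;16;15;13;11;5;7;9;10;8;6],[::(3,2)]));
  ((5,11,6),([::14;20;21;19;17;0;2;4;6;8;7;5;11;10;9;15;13;12;18;16;22;1;3],[::(3,2)]));
  ((5,11,7),([::3;4;22;20;21;15;16;14;12;10;8;2;0;6;5;23;1;7;9;11;13;19;17;18],[::(11,2)]));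
  ((5,11,8),([::22;21;23;0;24;5;11;13;14;12;6;4;10;8;2;3;9;7;1;20;18;16;15;17;19],[::(13,2)]));
  ((5,11,9),([::10;16;14;8;2;0;1;25;5;3;4;6;7;13;19;21;23;24;22;20;18;12;11;17;15;9],[::(22,2);(13,6)]));
  ((5,11,10),([::7;13;19;25;24;23;21;22;20;18;12;6;4;2;0;26;1;3;5;11;17;15;9;8;14;16;10],[::(5,2);(13,6)]));
  ((5,11,11),([::13;12;10;8;2;0;27;25;19;18;24;26;4;6;7;1;3;5;11;9;15;21;23;17;16;22;20;14],[::(26,2);(20,6)]));
  ((5,11,12),([::21;23;0;2;3;9;15;17;18;16;14;8;6;12;10;4;27;26;25;19;20;22;24;1;28;5;11;13;7],[::(17,2);(10,6)]));
  ((5,11,13),([::0;1;2;8;14;13;15;21;23;17;19;25;27;29;5;11;12;10;16;22;24;18;20;26;28;4;6;7;9;3],[::(28,2);(21,6)]));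
  ((5,11,14),([::20;26;24;18;17;23;29;0;6;4;2;8;9;3;1;7;5;30;28;22;16;15;14;12;10;11;13;19;25;27;21],[::(12,2);(22,6)]));
  ((6,1,4),([::9;7;8;2;3;4;10;11;5;6;0;1],[::]));
  ((6,1,5),([::10;4;3;9;11;5;12;0;1;2;8;7;6],[::]));
  ((6,1,6),([::7;8;2;10;11;9;1;0;6;5;13;12;4;3],[::]));
  ((6,1,7),([::13;12;6;8;7;1;10;9;0;14;5;11;2;3;4],[::]));
  ((6,1,8),([::12;14;8;9;3;13;7;6;0;15;5;4;10;11;1;2],[::]));
  ((6,1,9),([::13;14;8;2;3;9;7;1;0;6;12;11;5;4;10;16;15],[::(7,6)]));
  ((6,1,10),([::3;1;2;8;14;13;7;6;12;0;17;11;5;4;10;16;15;9],[::(12,6)]));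
  ((6,1,11),([::4;10;9;3;2;8;14;1;7;13;15;16;17;18;5;11;12;6;0],[::(9,6)]));
  ((6,1,12),([::4;5;11;17;16;10;9;15;14;8;2;3;1;7;13;19;0;6;12;18],[::(11,6)]));
  ((6,1,13),([::3;9;10;4;19;20;14;13;7;1;0;15;16;18;12;6;5;11;17;2;8],[::(7,6)]));
  ((6,1,14),([::4;2;8;14;20;21;15;9;3;19;13;12;18;17;11;5;6;7;1;0;16;10],[::(15,6)]));
  ((6,2,3),([::7;8;2;4;3;9;10;11;1;0;6;5],[::]));
  ((6,2,4),([::1;2;4;5;6;0;7;8;9;3;10;12;11],[::]));
  ((6,2,5),([::4;6;5;13;7;1;2;3;11;10;9;8;0;12],[::]));
  ((6,2,6),([::6;7;1;2;3;5;11;12;10;4;13;14;8;9;0],[::]));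
  ((6,2,7),([::13;15;14;4;10;9;3;2;8;7;5;11;12;6;0;1],[::]));
  ((6,2,8),([::16;5;7;8;10;4;3;9;15;14;13;2;1;12;11;0;6],[::]));
  ((6,2,9),([::4;10;16;17;1;0;6;12;11;5;7;13;14;8;9;15;3;2],[::(10,6)]));
  ((6,2,10),([::12;6;8;14;13;7;1;2;0;18;5;11;17;16;15;9;3;4;10],[::(9,6)]));
  ((6,2,11),([::2;0;6;12;18;19;13;7;1;3;4;5;11;17;16;10;9;15;14;8],[::(11,6)]));
  ((6,2,12),([::8;14;16;1;0;20;5;11;10;4;19;18;12;6;7;13;15;9;3;2;17],[::(10,6)]));
  ((6,2,13),([::14;20;4;2;18;12;13;19;3;9;15;21;0;1;17;11;5;6;7;8;10;16],[::(16,6)]));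
  ((6,2,14),([::16;10;11;17;15;9;7;13;19;2;8;14;20;3;4;21;22;0;1;18;12;6;5],[::(14,6)]));
  ((6,3,2),([::9;8;10;11;0;6;7;1;3;2;4;5],[::]));
  ((6,3,3),([::2;9;3;5;4;6;7;8;1;0;12;10;11],[::]));
  ((6,3,4),([::11;5;7;8;0;1;13;12;6;4;3;2;10;9],[::]));
  ((6,3,5),([::0;2;3;12;10;1;7;6;5;4;13;14;8;9;11],[::]));
  ((6,3,6),([::15;5;4;2;1;7;6;8;14;0;10;11;12;13;3;9],[::]));
  ((6,3,7),([::11;13;2;0;16;5;4;3;14;15;9;10;8;7;1;12;6],[::]));
  ((6,3,8),([::0;1;7;13;12;10;8;6;5;11;17;16;4;3;9;15;14;2],[::]));
  ((6,3,9),([::6;0;18;17;11;5;3;9;8;2;4;10;16;15;14;12;13;7;1],[::(6,6)]));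
  ((6,3,10),([::11;5;3;9;10;4;18;17;16;15;1;2;0;6;12;14;8;7;13;19],[::(9,6)]));
  ((6,3,11),([::19;13;14;20;18;12;10;16;17;11;5;6;7;1;0;15;9;3;4;2;8],[::(15,6)]));
  ((6,3,12),([::6;12;14;8;7;13;19;18;20;0;21;5;11;17;1;2;3;9;15;16;10;4],[::(12,6)]));
  ((6,3,13),([::1;7;13;14;8;2;19;17;11;5;4;3;20;18;16;10;9;15;21;22;0;6;12],[::(11,6)]));
  ((6,3,14),([::1;7;8;2;20;18;19;17;11;5;23;0;6;12;13;14;16;10;4;22;21;3;9;15],[::(7,6)]));
  ((6,4,1),([::3;1;0;2;4;6;7;8;9;10;11;5],[::]));
  ((6,4,2),([::0;7;6;8;10;9;11;5;4;3;2;1;12],[::]));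
  ((6,4,3),([::13;1;0;6;5;7;8;9;10;12;4;2;3;11],[::]));
  ((6,4,4),([::1;0;13;12;11;10;9;3;5;14;8;2;4;6;7],[::]));
  ((6,4,5),([::12;6;5;11;9;15;14;0;1;2;4;3;13;7;8;10],[::]));
  ((6,4,6),([::4;15;16;5;6;8;7;9;10;12;1;0;11;13;2;3;14],[::]));
  ((6,4,7),([::1;13;14;2;3;9;15;16;4;5;7;6;8;10;12;0;17;11],[::]));
  ((6,4,8),([::0;13;14;12;11;5;7;6;8;9;3;16;10;4;17;18;1;2;15],[::]));
  ((6,4,9),([::5;11;10;4;6;12;13;14;15;9;3;17;19;0;18;16;2;8;7;1],[::(7,6)]));
  ((6,4,10),([::11;17;19;13;12;18;3;5;4;6;7;1;2;8;14;16;10;9;15;0;20],[::(14,6)]));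
  ((6,4,11),([::14;15;21;1;7;8;2;18;20;19;13;12;6;4;10;9;3;5;11;17;16;0],[::(7,6)]));
  ((6,4,12),([::6;0;1;7;9;3;5;11;12;18;17;15;21;22;16;10;4;2;8;14;13;19;20],[::(6,6)]));
  ((6,4,13),([::14;20;2;8;6;0;22;16;17;23;1;7;13;19;18;12;11;10;9;15;21;3;5;4],[::(18,6)]));
  ((6,4,14),([::20;14;8;2;1;3;22;23;4;6;12;13;7;5;11;17;16;10;9;15;21;19;0;24;18],[::(11,6)]));
  ((6,5,1),([::2;1;3;4;6;0;12;11;10;8;9;7;5],[::]));
  ((6,5,2),([::12;4;6;8;9;10;11;13;0;1;7;5;3;2],[::]));
  ((6,5,3),([::5;6;0;14;8;10;12;13;11;9;7;1;2;3;4],[::]));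
  ((6,5,4),([::2;3;1;11;12;13;7;9;10;8;14;0;15;5;4;6],[::]));
  ((6,5,5),([::15;9;10;4;3;1;7;6;5;11;13;12;14;16;0;2;8],[::]));
  ((6,5,6),([::17;0;1;2;4;3;9;11;5;7;13;14;8;6;12;10;16;15],[::]));
  ((6,5,7),([::18;0;2;1;14;8;7;9;15;13;12;6;4;5;3;16;10;11;17],[::]));
  ((6,5,8),([::18;19;17;15;14;13;11;9;3;5;4;10;16;2;8;7;1;0;6;12],[::]));
  ((6,5,9),([::16;10;4;6;12;18;17;15;9;8;14;20;19;0;1;2;3;5;11;13;7],[::(11,6)]));
  ((6,5,10),([::20;4;5;11;13;7;9;15;14;8;6;12;18;19;3;2;0;21;1;17;16;10],[::(11,6)]));
  ((6,5,11),([::13;19;20;14;8;9;10;16;22;5;7;6;4;2;3;1;18;12;11;17;0;21;15],[::(17,6)]));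
  ((6,5,12),([::11;17;18;12;10;16;22;4;6;0;2;1;3;9;8;7;13;19;20;14;15;21;23;5],[::(16,6)]));
  ((6,5,13),([::11;17;23;22;16;10;9;15;21;19;13;7;1;3;4;5;6;8;2;0;24;18;12;14;20],[::(17,6)]));
  ((6,5,14),([::23;24;22;16;10;8;9;15;21;19;13;7;1;2;3;4;6;0;20;14;12;18;17;11;5;25],[::(16,6)]));
  ((6,6,1),([::13;12;0;8;10;11;9;7;5;6;4;3;2;1],[::]));
  ((6,6,2),([::6;7;1;3;4;2;0;14;13;12;10;8;9;11;5],[::]));
  ((6,6,3),([::15;0;6;8;14;13;12;11;9;10;4;2;1;3;5;7],[::]));
  ((6,6,4),([::2;8;10;11;0;1;3;4;6;12;13;14;16;15;9;7;5],[::]));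
  ((6,6,5),([::9;7;6;12;14;16;15;17;0;1;13;11;5;4;10;8;2;3],[::]));
  ((6,6,6),([::13;7;8;9;15;17;16;10;11;5;4;6;0;2;3;1;18;12;14],[::]));
  ((6,6,7),([::12;14;16;10;8;2;4;5;3;9;15;1;0;19;18;17;11;13;7;6],[::]));
  ((6,6,8),([::1;20;14;8;10;9;7;6;0;15;13;19;18;12;11;5;3;4;2;17;16],[::]));
  ((6,6,9),([::21;20;4;10;16;0;2;8;7;1;3;9;11;5;6;12;14;13;15;17;18;19],[::(7,6)]));
  ((6,6,10),([::8;2;1;7;9;3;4;10;12;6;5;11;17;16;14;20;22;0;21;15;13;19;18],[::(7,6)]));
  ((6,6,11),([::6;12;18;0;22;16;10;9;15;14;8;7;13;19;17;11;5;4;2;3;1;23;21;20],[::(12,6)]));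
  ((6,6,12),([::10;4;3;9;15;21;20;1;7;13;12;6;5;11;17;19;18;16;14;8;2;0;23;22;24],[::(9,6)]));
  ((6,6,13),([::16;14;8;2;1;25;5;11;17;15;13;7;6;12;18;19;20;0;24;4;10;9;3;23;21;22],[::(9,6)]));
  ((6,6,14),([::17;11;13;19;20;21;23;2;0;25;4;5;26;1;22;16;10;12;18;24;3;9;15;14;8;7;6],[::(14,6)]));
  ((6,7,1),([::14;13;4;2;0;1;3;5;6;8;7;9;10;12;11],[::]));
  ((6,7,2),([::14;4;6;7;5;11;9;8;10;12;13;15;0;1;3;2],[::]));
  ((6,7,3),([::12;14;15;9;7;8;6;4;5;3;2;13;11;10;16;1;0],[::]));
  ((6,7,4),([::9;10;4;3;1;2;8;6;7;13;15;17;0;16;14;12;11;5],[::]));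
  ((6,7,5),([::6;8;9;11;17;15;16;14;13;0;18;12;10;4;5;7;1;3;2],[::]));
  ((6,7,6),([::11;9;7;13;12;14;0;1;3;2;16;15;17;18;4;10;8;6;5;19],[::]));
  ((6,7,7),([::9;15;13;12;14;8;10;11;5;6;4;3;18;20;19;0;2;17;16;1;7],[::]));
  ((6,7,8),([::14;8;10;11;5;4;2;1;7;9;3;19;17;18;16;0;20;21;15;13;12;6],[::]));
  ((6,7,9),([::21;15;13;12;6;5;11;10;4;2;8;14;16;17;19;18;20;3;9;7;1;22;0],[::(7,6)]));
  ((6,7,10),([::12;6;0;18;19;17;11;5;7;13;14;15;16;10;4;2;8;9;3;1;23;21;22;20],[::(8,6)]));
  ((6,7,11),([::22;16;10;8;9;11;17;23;21;15;13;19;0;1;2;3;4;6;7;5;24;18;12;14;20],[::(17,6)]));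
  ((6,7,12),([::25;1;2;22;23;21;20;19;13;7;9;15;14;8;10;16;18;12;6;0;24;4;3;5;11;17],[::(12,6)]));
  ((6,7,13),([::26;25;23;17;11;9;15;21;19;13;12;18;16;10;4;2;3;24;22;20;14;8;7;1;0;6;5],[::(16,6)]));
  ((6,7,14),([::8;14;12;6;4;5;11;17;19;25;26;0;27;21;20;22;23;1;7;13;15;9;3;2;24;18;16;10],[::(11,6)]));
  ((6,8,1),([::2;12;10;8;9;11;13;15;14;0;1;3;4;5;7;6],[::]));
  ((6,8,2),([::13;11;5;3;14;12;10;8;9;7;6;4;2;1;0;16;15],[::]));
  ((6,8,3),([::11;12;0;2;4;3;9;10;8;6;5;7;13;15;14;16;17;1],[::]));
  ((6,8,4),([::6;5;7;8;10;4;2;0;1;3;9;11;17;18;12;14;13;15;16],[::]));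
  ((6,8,5),([::5;4;2;0;19;17;18;16;15;9;3;1;7;13;14;12;6;8;10;11],[::]));
  ((6,8,6),([::2;17;16;18;3;1;7;8;14;12;10;9;11;13;15;0;20;19;4;6;5],[::]));
  ((6,8,7),([::12;6;7;9;10;8;14;13;15;21;0;1;3;5;11;17;19;20;4;2;18;16],[::]));
  ((6,8,8),([::13;19;17;11;9;15;21;22;0;6;7;5;4;3;20;18;1;2;8;10;12;14;16],[::]));
  ((6,8,9),([::21;23;5;3;2;1;0;18;12;13;19;20;22;4;6;8;14;16;10;11;17;15;9;7],[::(14,6)]));
  ((6,8,10),([::21;23;22;3;4;6;12;14;8;2;1;24;0;19;20;18;16;10;9;15;17;11;5;7;13],[::(11,6)]));
  ((6,8,11),([::12;6;4;10;11;5;7;13;14;8;9;15;16;18;24;0;25;1;21;19;17;23;3;2;22;20],[::(10,6)]));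
  ((6,8,12),([::26;5;7;13;14;8;9;15;16;10;12;18;19;25;4;6;0;2;1;3;24;22;20;21;23;17;11],[::(13,6)]));
  ((6,8,13),([::16;22;20;14;12;18;24;26;25;3;2;1;23;21;15;13;19;17;11;5;27;0;6;7;9;8;10;4],[::(17,6)]));
  ((6,8,14),([::19;17;11;5;7;13;14;8;2;1;24;26;27;25;23;0;28;22;20;21;15;9;3;4;6;12;18;16;10],[::(12,6)]));
  ((6,9,1),([::16;10;8;7;5;6;4;3;1;2;0;15;13;14;12;11;9],[::]));
  ((6,9,2),([::8;10;11;12;0;16;14;13;15;17;1;3;9;7;6;5;4;2],[::]));
  ((6,9,3),([::10;9;15;16;3;1;18;17;0;2;4;6;5;7;8;14;12;11;13],[::]));
  ((6,9,4),([::7;5;11;13;12;14;8;9;10;16;15;17;19;18;0;6;4;2;1;3],[::]));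
  ((6,9,5),([::6;12;11;13;14;8;7;5;20;1;3;4;2;0;19;18;16;10;9;15;17],[::]));
  ((6,9,6),([::21;1;3;19;20;14;12;13;15;9;7;6;4;5;11;10;8;2;0;16;18;17],[::]));
  ((6,9,7),([::4;5;22;20;21;15;13;11;17;19;2;0;1;18;16;14;12;6;7;8;10;9;3],[::]));
  ((6,9,8),([::23;1;2;8;14;20;19;17;18;12;10;11;9;7;13;15;16;22;0;6;4;5;3;21],[::]));
  ((6,9,9),([::6;12;14;8;7;13;15;9;3;1;20;18;16;17;19;21;22;23;24;5;11;10;4;2;0],[::(10,6)]));
  ((6,9,10),([::17;11;5;6;0;24;22;23;25;19;21;20;18;12;10;16;14;8;7;13;15;9;3;4;2;1],[::(13,6)]));
  ((6,9,11),([::22;24;25;23;21;0;1;2;8;14;15;9;11;17;19;13;7;6;4;3;5;26;20;18;12;10;16],[::(14,6)]));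
  ((6,9,12),([::1;7;9;3;4;10;8;2;24;26;20;22;0;6;12;18;17;16;15;14;13;11;5;27;25;23;21;19],[::(7,6)]));
  ((6,9,13),([::0;28;26;20;19;13;7;6;12;14;8;2;25;27;21;23;22;24;1;3;5;4;10;16;18;17;11;9;15],[::(12,6)]));
  ((6,9,14),([::17;23;22;16;18;24;0;2;26;20;14;8;6;12;10;11;9;7;1;3;4;5;29;28;27;25;19;13;15;21],[::(21,6)]));
  ((6,10,1),([::1;0;12;10;8;6;4;2;3;5;7;9;11;13;14;15;16;17],[::(9,2)]));
  ((6,10,2),([::10;8;2;0;18;17;16;14;12;11;13;15;9;7;6;4;5;3;1],[::(9,2)]));
  ((6,10,3),([::3;1;19;13;15;16;17;18;0;14;12;10;8;2;4;5;6;7;9;11],[::(10,2)]));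
  ((6,10,4),([::19;4;5;11;13;12;10;9;7;6;8;2;0;20;1;3;18;16;14;15;17],[::(12,2)]));
  ((6,10,5),([::0;21;19;18;12;6;4;2;1;3;5;11;9;10;8;7;13;15;17;16;14;20],[::(5,2)]));
  ((6,10,6),([::5;3;4;2;19;17;0;22;20;21;15;13;14;16;10;8;6;7;9;11;12;18;1],[::(10,2)]));
  ((6,10,7),([::22;21;19;1;2;8;10;12;13;11;9;7;6;0;18;20;14;16;15;17;23;5;3;4],[::(10,2)]));
  ((6,10,8),([::6;5;4;10;12;14;15;21;20;1;3;22;16;18;24;23;0;2;8;7;9;11;13;19;17],[::(12,2)]));
  ((6,10,9),([::16;18;12;14;15;17;19;13;11;5;3;9;10;4;24;22;20;21;23;25;0;6;7;1;2;8],[::(24,2);(6,6)]));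
  ((6,10,10),([::14;8;2;3;9;10;4;5;11;17;19;21;22;20;18;16;15;13;7;1;26;24;23;25;0;6;12],[::(18,2);(9,6)]));
  ((6,10,11),([::7;13;14;8;9;15;17;23;21;22;24;18;16;10;4;2;0;6;12;11;5;3;1;27;25;26;20;19],[::(17,2);(11,6)]));
  ((6,10,12),([::23;17;16;22;20;14;12;18;19;13;7;5;28;27;21;15;9;11;10;8;6;4;3;1;24;26;25;2;0],[::(6,2);(18,6)]));
  ((6,10,13),([::21;15;16;22;28;0;2;4;3;1;25;23;29;27;26;24;18;12;6;5;7;13;19;20;14;8;10;9;11;17],[::(3,2);(17,6)]));
  ((6,10,14),([::19;13;12;18;17;11;9;15;16;10;4;5;7;1;3;28;26;25;27;2;0;6;8;14;20;22;24;30;29;23;21],[::(23,2);(15,6)]));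
  ((6,11,1),([::4;2;0;13;14;16;15;17;18;1;3;5;6;8;7;9;11;12;10],[::(4,2)]));
  ((6,11,2),([::11;9;3;5;4;18;0;2;1;19;17;16;15;13;14;12;10;8;6;7],[::(11,2)]));
  ((6,11,3),([::11;17;15;13;14;12;10;16;18;20;1;3;9;8;7;6;5;4;2;0;19],[::(2,2)]));
  ((6,11,4),([::14;13;7;6;8;9;15;16;17;19;21;1;3;5;11;12;10;4;2;0;20;18],[::(19,2)]));
  ((6,11,5),([::14;8;7;13;19;18;16;15;17;11;9;10;12;6;5;3;1;22;20;21;0;2;4],[::(3,2)]));
  ((6,11,6),([::9;8;14;12;18;20;22;0;1;2;3;5;7;6;4;10;16;15;17;11;13;19;21;23],[::(21,2)]));
  ((6,11,7),([::19;21;15;17;16;14;12;10;8;9;3;22;20;18;24;0;23;4;2;1;7;6;5;11;13],[::(13,2)]));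
  ((6,11,8),([::11;9;7;1;25;24;22;16;10;8;14;15;17;19;13;12;18;20;21;23;3;4;2;0;6;5],[::(23,2)]));
  ((6,11,9),([::11;5;4;25;23;17;18;24;26;0;2;1;3;9;7;6;8;10;12;14;20;22;16;15;21;19;13],[::(25,2);(19,6)]));
  ((6,11,10),([::22;24;2;3;5;11;17;15;9;8;14;16;10;12;18;19;13;7;6;4;26;0;1;27;25;23;21;20],[::(23,2);(13,6)]));
  ((6,11,11),([::4;5;6;7;9;15;14;8;2;3;26;28;1;24;22;16;10;12;18;20;21;19;13;11;17;23;25;27;0],[::(24,2);(14,6)]));
  ((6,11,12),([::10;9;11;17;23;29;0;2;4;6;8;7;5;3;1;25;19;13;14;12;18;24;22;16;15;21;27;28;26;20],[::(3,2);(21,6)]));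
  ((6,11,13),([::17;23;24;18;12;11;13;19;20;14;15;21;22;16;10;4;6;8;2;0;29;27;25;26;28;30;5;7;1;3;9],[::(29,2);(18,6)]));
  ((6,11,14),([::16;22;21;15;9;8;14;20;18;12;6;7;13;19;25;27;29;31;30;28;26;24;23;17;11;5;3;1;0;2;4;10],[::(27,2);(10,6)]));
  ((7,1,3),([::2;8;7;6;5;11;0;1;3;4;10;9],[::]));
  ((7,1,4),([::11;10;9;3;1;2;8;7;0;12;6;5;4],[::]));
  ((7,1,5),([::12;6;0;13;7;5;4;3;11;10;9;8;2;1],[::]));
  ((7,1,6),([::4;13;0;9;8;14;5;6;7;1;2;3;12;11;10],[::]));
  ((7,1,7),([::12;6;5;7;1;0;15;9;8;2;3;13;14;4;10;11],[::]));
  ((7,1,8),([::9;8;10;11;5;16;0;1;12;6;7;13;2;3;14;15;4],[::]));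
  ((7,1,9),([::0;17;1;13;7;6;12;11;5;4;10;16;15;14;8;2;3;9],[::(9,6)]));
  ((7,1,10),([::11;17;16;10;4;5;6;8;14;15;9;3;2;1;7;13;0;18;12],[::(13,6)]));
  ((7,1,11),([::16;10;4;5;11;13;7;6;12;18;19;0;1;2;8;14;15;9;3;17],[::(9,6)]));
  ((7,1,12),([::8;14;15;9;11;17;2;3;18;12;13;19;4;10;16;1;0;20;5;6;7],[::(14,6)]));
  ((7,1,13),([::15;9;11;17;18;12;6;0;1;7;13;14;8;2;3;19;20;21;5;4;10;16],[::(13,6)]));
  ((7,1,14),([::3;20;21;4;2;1;18;12;6;5;11;17;0;22;16;10;9;15;14;8;7;13;19],[::(12,6)]));
  ((7,2,2),([::6;8;7;1;0;11;10;9;3;2;4;5],[::]));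
  ((7,2,3),([::11;0;6;7;1;2;3;4;5;12;10;9;8],[::]));
  ((7,2,4),([::7;9;1;3;2;8;0;13;12;11;10;4;5;6],[::]));
  ((7,2,5),([::7;13;0;1;3;2;11;12;6;5;4;10;9;8;14],[::]));
  ((7,2,6),([::1;3;9;10;11;13;12;2;8;7;6;0;15;5;4;14],[::]));
  ((7,2,7),([::6;0;16;5;3;2;4;10;11;12;1;7;13;14;15;9;8],[::]));
  ((7,2,8),([::16;14;8;10;4;5;6;0;17;11;12;13;7;1;2;3;15;9],[::]));
  ((7,2,9),([::17;11;5;4;6;12;18;0;1;2;3;9;15;16;10;8;14;13;7],[::(12,6)]));
  ((7,2,10),([::12;18;17;11;5;7;6;0;14;8;9;15;16;10;4;3;2;1;19;13],[::(14,6)]));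
  ((7,2,11),([::0;15;9;7;13;19;20;14;8;10;16;1;2;3;4;5;6;12;18;17;11],[::(15,6)]));
  ((7,2,12),([::5;11;13;7;1;2;18;12;6;0;21;20;19;17;16;10;4;3;9;15;14;8],[::(9,6)]));
  ((7,2,13),([::13;19;18;17;15;14;8;2;1;7;9;3;20;21;4;10;16;22;0;6;12;11;5],[::(7,6)]));
  ((7,2,14),([::10;8;2;4;22;16;17;23;0;18;12;11;5;6;7;1;19;13;14;20;21;15;9;3],[::(18,6)]));
  ((7,3,1),([::1;11;10;9;8;7;6;0;2;3;5;4],[::]));
  ((7,3,2),([::8;1;2;4;3;5;6;0;12;11;10;9;7],[::]));
  ((7,3,3),([::11;13;12;4;5;6;7;9;3;2;1;0;8;10],[::]));
  ((7,3,4),([::4;2;1;10;9;11;5;6;7;8;14;0;13;12;3],[::]));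
  ((7,3,5),([::15;5;4;2;1;7;6;8;9;3;13;12;11;10;0;14],[::]));
  ((7,3,6),([::12;14;15;9;11;10;4;3;1;0;16;5;6;7;13;2;8],[::]));
  ((7,3,7),([::4;5;17;1;0;12;13;14;2;8;6;7;9;3;15;16;10;11],[::]));
  ((7,3,8),([::16;14;8;6;7;1;0;13;15;2;3;9;10;4;5;18;17;11;12],[::]));
  ((7,3,9),([::4;18;19;1;2;0;6;12;13;7;8;14;15;9;10;16;17;11;5;3],[::(12,6)]));
  ((7,3,10),([::15;9;10;16;17;11;13;19;18;12;6;8;14;20;5;4;3;2;0;1;7],[::(14,6)]));
  ((7,3,11),([::14;8;7;13;11;5;21;19;20;4;10;16;15;17;18;12;6;0;1;2;3;9],[::(9,6)]));
  ((7,3,12),([::21;22;0;2;8;9;3;1;7;13;19;20;14;15;16;10;4;6;12;18;17;11;5],[::(7,6)]));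
  ((7,3,13),([::14;20;18;17;16;10;4;3;9;8;2;0;6;12;11;5;23;22;21;15;13;7;1;19],[::(8,6)]));
  ((7,3,14),([::12;6;0;19;17;11;5;24;18;16;10;4;3;2;1;7;13;14;8;9;15;21;20;22;23],[::(11,6)]));
  ((7,4,1),([::9;2;0;1;12;11;10;8;7;6;5;3;4],[::]));
  ((7,4,2),([::5;7;6;12;0;8;9;10;11;13;1;2;3;4],[::]));
  ((7,4,3),([::13;7;9;10;8;2;3;4;5;6;0;1;14;12;11],[::]));
  ((7,4,4),([::13;7;5;4;10;11;12;6;8;9;15;14;0;1;3;2],[::]));
  ((7,4,5),([::5;16;10;12;6;7;8;2;1;0;15;14;13;11;9;3;4],[::]));
  ((7,4,6),([::8;6;5;4;3;9;15;14;13;11;17;16;10;12;0;2;1;7],[::]));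
  ((7,4,7),([::8;9;15;17;16;14;1;7;6;0;2;3;4;10;11;13;12;18;5],[::]));
  ((7,4,8),([::7;1;3;9;8;10;4;2;16;17;11;12;13;15;14;0;6;5;19;18],[::]));
  ((7,4,9),([::5;11;17;2;1;20;0;19;18;3;4;6;12;13;7;8;14;16;10;9;15],[::(11,6)]));
  ((7,4,10),([::15;9;8;14;16;10;11;17;19;13;7;1;0;21;20;4;2;3;5;6;12;18],[::(13,6)]));
  ((7,4,11),([::3;5;7;6;0;2;1;18;12;13;19;20;14;8;9;15;17;11;10;16;22;21;4],[::(14,6)]));
  ((7,4,12),([::8;14;16;10;4;22;23;1;0;2;3;5;11;17;18;12;6;7;13;19;20;21;15;9],[::(12,6)]));
  ((7,4,13),([::6;0;24;22;23;21;20;19;13;7;1;3;9;15;16;10;4;5;11;17;18;12;14;8;2],[::(6,6)]));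
  ((7,4,14),([::18;24;22;16;17;23;21;15;9;11;10;12;6;7;1;0;20;14;8;2;3;4;5;25;19;13],[::(20,6)]));
  ((7,5,1),([::13;1;7;5;4;3;2;0;12;11;10;9;8;6],[::]));
  ((7,5,2),([::14;5;11;9;10;12;13;0;1;2;3;4;6;8;7],[::]));
  ((7,5,3),([::6;12;10;0;1;2;4;3;5;7;8;9;15;14;13;11],[::]));
  ((7,5,4),([::8;7;6;4;2;0;1;16;5;11;10;9;3;14;15;13;12],[::]));
  ((7,5,5),([::0;6;8;14;2;3;4;5;11;10;12;13;15;16;17;1;7;9],[::]));
  ((7,5,6),([::3;1;18;16;17;4;10;9;8;7;5;11;12;6;0;2;15;14;13],[::]));
  ((7,5,7),([::11;5;3;9;7;8;2;4;18;17;19;1;0;6;12;13;14;15;16;10],[::]));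
  ((7,5,8),([::16;14;20;1;3;9;10;8;2;17;18;19;4;5;11;12;13;15;0;6;7],[::]));
  ((7,5,9),([::15;9;8;14;20;4;10;16;17;18;19;21;1;0;2;3;5;11;13;7;6;12],[::(11,6)]));
  ((7,5,10),([::4;10;16;15;14;8;7;13;19;2;0;17;18;20;21;22;1;3;9;11;5;6;12],[::(9,6)]));
  ((7,5,11),([::15;9;10;16;22;0;1;3;21;20;18;19;17;23;5;11;12;6;7;13;14;8;2;4],[::(11,6)]));
  ((7,5,12),([::0;6;7;1;20;18;19;21;15;17;11;5;24;23;22;3;9;8;2;4;10;16;14;13;12],[::(6,6)]));
  ((7,5,13),([::17;18;16;22;24;25;19;20;0;6;12;13;7;1;2;8;10;4;5;11;9;3;23;21;15;14],[::(8,6)]));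
  ((7,5,14),([::19;20;18;17;11;5;4;10;9;3;24;23;2;8;14;12;6;0;25;26;1;7;13;15;21;22;16],[::(7,6)]));
  ((7,6,1),([::12;10;8;7;5;6;4;3;2;1;0;9;11;13;14],[::]));
  ((7,6,2),([::2;8;7;6;4;10;9;11;13;12;14;15;0;1;3;5],[::]));
  ((7,6,3),([::2;4;10;9;7;6;5;3;1;0;11;12;13;15;16;14;8],[::]));
  ((7,6,4),([::9;7;6;0;12;11;10;8;2;4;5;3;1;13;14;15;17;16],[::]));
  ((7,6,5),([::6;0;1;7;8;2;15;13;11;9;10;12;14;16;17;18;5;4;3],[::]));
  ((7,6,6),([::8;10;16;2;0;6;12;13;14;15;1;3;4;5;7;9;11;17;18;19],[::]));
  ((7,6,7),([::15;9;8;2;4;6;12;14;20;0;1;3;5;7;13;19;18;17;16;10;11],[::]));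
  ((7,6,8),([::20;21;15;17;11;13;19;3;9;8;7;6;0;1;2;18;16;14;12;10;4;5],[::]));
  ((7,6,9),([::11;5;3;9;10;4;2;8;6;0;1;7;13;15;16;22;21;20;19;17;18;12;14],[::(6,6)]));
  ((7,6,10),([::17;11;5;6;4;22;23;0;1;3;21;15;13;19;20;14;12;18;16;10;9;7;8;2],[::(16,6)]));
  ((7,6,11),([::16;10;8;14;20;1;2;4;6;5;7;13;15;9;3;22;21;23;24;0;19;18;12;11;17],[::(13,6)]));
  ((7,6,12),([::9;8;6;0;20;14;12;13;19;25;23;17;15;21;22;16;18;24;4;3;2;1;7;5;11;10],[::(19,6)]));
  ((7,6,13),([::8;2;0;26;24;3;9;11;5;4;10;16;17;19;25;23;22;1;7;13;14;15;21;20;18;12;6],[::(8,6)]));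
  ((7,6,14),([::5;27;0;6;12;18;20;14;16;22;21;15;9;7;13;19;25;26;24;23;17;11;10;8;2;1;3;4],[::(18,6)]));
  ((7,7,1),([::6;4;5;7;1;3;2;0;15;13;14;12;11;10;8;9],[::]));
  ((7,7,2),([::16;0;15;13;12;11;10;8;9;7;1;2;4;6;5;3;14],[::]));
  ((7,7,3),([::16;0;1;3;4;5;6;12;10;11;9;7;8;2;14;13;15;17],[::]));
  ((7,7,4),([::13;11;5;6;4;17;18;1;0;2;3;9;7;8;10;16;15;14;12],[::]));
  ((7,7,5),([::9;10;16;2;0;19;18;4;5;6;8;7;1;3;17;15;13;11;12;14],[::]));
  ((7,7,6),([::8;9;3;2;4;19;20;14;12;10;11;13;7;5;6;0;1;16;18;17;15],[::]));
  ((7,7,7),([::11;13;15;17;19;3;1;0;2;18;12;6;7;8;9;10;16;14;20;21;5;4],[::]));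
  ((7,7,8),([::19;20;22;1;7;13;15;21;4;10;8;9;3;2;0;6;5;11;12;14;16;17;18],[::]));
  ((7,7,9),([::6;7;9;8;2;4;3;1;0;18;12;10;11;13;19;20;14;16;22;21;15;17;23;5],[::(18,6)]));
  ((7,7,10),([::21;15;16;10;4;5;11;13;12;14;8;2;3;9;7;1;24;23;22;20;18;17;19;0;6],[::(6,6)]));
  ((7,7,11),([::2;22;21;20;19;13;7;6;12;18;16;10;8;14;15;9;11;17;23;25;0;24;4;5;3;1],[::(12,6)]));
  ((7,7,12),([::8;2;23;25;19;20;22;21;15;14;13;7;1;3;9;11;5;4;10;12;6;0;26;24;18;16;17],[::(8,6)]));
  ((7,7,13),([::23;25;27;5;4;10;16;18;12;11;17;15;9;8;14;20;26;24;2;3;1;0;6;7;13;19;21;22],[::(13,6)]));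
  ((7,7,14),([::12;6;7;13;15;9;3;5;11;17;18;16;10;8;14;20;21;22;23;0;1;24;26;28;27;4;2;25;19],[::(11,6)]));
  ((7,8,1),([::12;14;16;10;8;9;11;13;15;0;1;2;3;4;5;7;6],[::]));
  ((7,8,2),([::14;13;12;0;2;3;1;17;16;15;9;11;10;8;6;4;5;7],[::]));
  ((7,8,3),([::1;18;12;11;10;8;6;0;2;3;4;5;7;9;15;17;16;14;13],[::]));
  ((7,8,4),([::1;0;2;3;17;11;10;8;9;7;5;4;6;12;14;16;15;13;19;18],[::]));
  ((7,8,5),([::0;6;8;10;12;13;15;16;18;17;11;9;7;1;2;3;5;4;19;20;14],[::]));
  ((7,8,6),([::14;12;13;7;9;3;2;18;17;19;20;0;1;21;15;16;10;8;6;4;5;11],[::]));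
  ((7,8,7),([::20;14;13;19;2;3;4;10;12;11;9;7;8;6;5;22;1;18;16;17;15;21;0],[::]));
  ((7,8,8),([::23;17;15;16;14;12;6;7;1;19;13;11;10;8;9;3;5;4;22;21;20;18;0;2],[::]));
  ((7,8,9),([::7;13;19;0;2;8;10;16;15;9;11;17;18;12;14;20;21;22;23;24;1;3;5;4;6],[::(15,6)]));
  ((7,8,10),([::15;9;8;14;20;21;22;24;0;6;4;2;1;25;23;3;5;7;13;19;18;12;11;17;16;10],[::(15,6)]));
  ((7,8,11),([::11;5;26;25;0;6;12;18;16;10;9;15;17;19;20;21;23;24;22;1;3;4;2;8;14;13;7],[::(11,6)]));
  ((7,8,12),([::9;15;14;8;6;12;18;17;11;5;7;13;19;25;23;21;20;22;16;10;4;2;3;1;0;27;26;24],[::(13,6)]));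
  ((7,8,13),([::6;8;14;20;26;28;5;7;9;10;4;3;2;0;1;24;22;16;15;21;27;25;23;17;11;12;18;19;13],[::(18,6)]));
  ((7,8,14),([::2;1;3;9;15;16;10;8;14;20;22;28;29;0;24;26;27;21;19;25;23;17;18;12;6;4;5;11;13;7],[::(11,6)]));
  ((7,9,1),([::3;4;10;8;6;5;7;9;11;12;14;13;15;16;0;17;1;2],[::]));
  ((7,9,2),([::1;2;15;17;18;0;6;4;3;5;7;8;10;9;11;13;12;14;16],[::]));
  ((7,9,3),([::11;10;16;2;8;9;7;5;6;4;3;1;0;18;19;17;15;13;14;12],[::]));
  ((7,9,4),([::17;11;13;15;16;14;8;10;9;7;6;12;18;19;0;20;1;3;2;4;5],[::]));
  ((7,9,5),([::3;9;8;14;12;11;5;6;7;13;15;17;16;18;20;19;21;1;0;2;4;10],[::]));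
  ((7,9,6),([::14;15;9;10;4;2;8;6;12;11;13;7;5;3;20;18;16;17;19;21;22;0;1],[::]));
  ((7,9,7),([::6;0;2;4;5;23;21;22;20;19;18;16;14;8;10;9;3;1;7;13;12;11;17;15],[::]));
  ((7,9,8),([::13;14;20;21;2;4;3;5;6;12;18;19;0;23;22;24;1;7;9;11;17;15;16;10;8],[::]));
  ((7,9,9),([::23;24;4;3;5;6;12;18;20;22;21;19;17;11;10;16;14;8;9;15;13;7;1;25;0;2],[::(12,6)]));
  ((7,9,10),([::7;13;14;8;9;15;17;11;5;3;4;10;12;6;0;26;24;25;23;21;19;20;18;16;22;1;2],[::(10,6)]));
  ((7,9,11),([::19;13;15;21;27;5;3;9;10;16;17;11;12;18;20;14;8;7;6;4;2;0;1;23;25;26;24;22],[::(16,6)]));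
  ((7,9,12),([::15;21;20;14;16;22;28;1;2;4;3;5;6;0;27;26;25;19;13;7;9;11;17;23;24;18;12;10;8],[::(19,6)]));
  ((7,9,13),([::9;11;17;18;12;13;19;25;1;0;6;4;28;27;29;23;21;15;14;20;26;24;22;16;10;8;7;5;3;2],[::(17,6)]));
  ((7,9,14),([::7;1;30;5;11;13;12;6;4;10;8;2;3;9;15;21;19;18;24;23;17;16;14;20;22;28;27;29;0;25;26],[::(7,6)]));
  ((7,10,1),([::15;16;18;17;0;1;2;4;6;8;14;12;13;11;10;9;7;5;3],[::(7,2)]));
  ((7,10,2),([::18;16;15;17;3;2;4;5;6;8;10;12;14;13;11;9;7;1;0;19],[::(17,2)]));
  ((7,10,3),([::7;1;0;19;20;18;16;14;12;6;5;4;3;2;17;15;13;11;9;10;8],[::(14,2)]));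
  ((7,10,4),([::18;16;0;6;4;3;2;1;7;5;21;20;19;17;15;13;14;12;10;8;9;11],[::(11,2)]));
  ((7,10,5),([::13;19;21;15;17;11;12;14;20;18;16;22;0;2;1;3;4;5;6;8;10;9;7],[::(8,2)]));
  ((7,10,6),([::13;7;6;4;22;16;14;15;17;23;21;20;19;18;0;2;1;3;5;11;9;8;10;12],[::(16,2)]));
  ((7,10,7),([::20;18;17;19;21;2;0;1;7;13;12;11;9;3;5;24;22;23;4;6;8;10;16;15;14],[::(20,2)]));
  ((7,10,8),([::1;3;5;11;17;23;21;19;13;15;14;12;18;24;25;0;2;4;6;7;8;9;10;16;22;20],[::(2,2)]));
  ((7,10,9),([::18;12;11;17;19;13;7;8;14;16;10;9;15;21;23;22;20;26;24;25;0;1;3;5;6;4;2],[::(5,2);(13,6)]));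
  ((7,10,10),([::8;14;16;10;9;15;17;11;12;18;20;22;0;26;27;5;6;4;3;1;2;24;25;23;21;19;13;7],[::(22,2);(13,6)]));
  ((7,10,11),([::24;18;17;23;25;19;20;26;28;22;16;10;8;7;9;11;13;12;14;15;21;27;4;5;3;1;2;0;6],[::(9,2);(23,6)]));
  ((7,10,12),([::26;25;23;17;15;21;19;13;11;5;6;0;24;22;16;14;20;18;12;10;9;7;8;2;1;29;28;4;3;27],[::(24,2);(18,6)]));
  ((7,10,13),([::23;25;19;17;15;14;16;18;24;26;28;29;30;5;11;13;7;1;0;6;12;10;4;3;9;8;2;27;21;22;20],[::(16,2);(6,6)]));
  ((7,10,14),([::4;2;28;26;24;22;20;19;13;7;8;14;16;10;9;15;21;23;25;31;30;29;27;1;0;6;12;18;17;11;5;3],[::(23,2);(14,6)]));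
  ((7,11,1),([::1;0;2;4;6;7;5;3;17;19;18;16;15;14;13;11;9;8;10;12],[::(12,2)]));
  ((7,11,2),([::11;9;15;16;17;18;20;1;2;0;19;13;14;12;10;8;7;5;3;4;6],[::(5,2)]));
  ((7,11,3),([::19;17;16;15;9;11;10;12;13;14;20;18;2;0;21;1;3;5;7;8;6;4],[::(7,2)]));
  ((7,11,4),([::11;9;8;10;4;3;1;7;5;6;0;22;21;20;18;16;14;12;13;15;17;19;2],[::(18,2)]));
  ((7,11,5),([::8;14;13;19;18;12;6;4;2;0;22;20;21;23;1;3;5;7;9;10;11;17;16;15],[::(6,2)]));
  ((7,11,6),([::6;5;4;2;0;23;22;24;1;7;13;14;8;10;12;11;17;19;21;20;18;16;15;9;3],[::(18,2)]));
  ((7,11,7),([::16;14;12;18;17;19;20;22;24;4;10;9;11;13;7;8;2;1;3;5;6;0;25;23;21;15],[::(23,2)]));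
  ((7,11,8),([::23;24;26;1;22;20;21;0;25;4;10;12;11;13;7;6;5;3;2;8;14;16;18;19;17;15;9],[::(16,2)]));
  ((7,11,9),([::19;25;27;1;7;8;2;0;6;12;14;16;18;17;15;13;11;5;3;9;10;4;26;24;23;22;21;20],[::(17,2);(6,6)]));
  ((7,11,10),([::10;8;9;11;13;19;20;14;12;6;4;5;28;26;27;25;24;18;16;22;21;15;17;23;0;2;3;1;7],[::(13,2);(19,6)]));
  ((7,11,11),([::29;27;26;24;18;12;6;8;14;13;7;1;25;23;21;22;20;19;17;11;10;16;15;9;3;5;4;2;0;28],[::(25,2);(12,6)]));
  ((7,11,12),([::19;13;7;5;11;17;16;10;8;14;12;6;4;2;0;29;28;27;26;25;23;22;21;15;9;3;1;30;24;18;20],[::(2,2);(12,6)]));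
  ((7,11,13),([::8;6;7;9;11;10;12;13;15;21;27;1;31;25;19;18;24;30;28;29;3;5;4;2;0;26;20;14;16;22;23;17],[::(8,2);(22,6)]));
  ((7,11,14),([::31;4;5;3;2;0;6;8;14;20;26;25;19;13;15;21;22;16;10;12;18;17;11;9;7;1;32;30;28;27;29;23;24],[::(8,2);(16,6)]));
  ((8,1,2),([::11;0;10;9;3;4;5;6;7;8;2;1],[::]));
  ((8,1,3),([::1;3;2;8;9;10;11;4;5;6;7;0;12],[::]));
  ((8,1,4),([::11;5;7;6;12;13;0;8;9;10;4;3;2;1],[::]));
  ((8,1,5),([::0;6;4;5;11;12;13;14;8;7;1;2;3;9;10],[::]));
  ((8,1,6),([::1;0;15;9;10;4;2;12;11;5;6;7;8;14;13;3],[::]));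
  ((8,1,7),([::2;8;10;16;0;1;12;11;5;6;7;13;14;15;9;3;4],[::]));
  ((8,1,8),([::1;0;17;11;9;15;16;10;4;3;2;14;8;7;13;12;6;5],[::]));
  ((8,1,9),([::10;4;6;12;13;7;8;14;15;9;3;2;1;0;18;5;11;17;16],[::(10,6)]));
  ((8,1,10),([::2;1;3;9;15;14;8;7;13;19;0;6;12;11;5;4;10;16;17;18],[::(9,6)]));
  ((8,1,11),([::7;1;2;8;6;0;20;5;11;12;18;17;16;10;4;3;9;15;14;13;19],[::(6,6)]));
  ((8,1,12),([::21;19;13;7;8;14;20;4;10;11;5;6;12;18;17;16;0;1;2;3;9;15],[::(9,6)]));
  ((8,1,13),([::2;19;20;21;22;16;10;4;3;5;11;17;18;12;6;0;1;7;13;14;8;9;15],[::(10,6)]));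
  ((8,1,14),([::8;14;16;10;4;5;11;17;23;22;21;15;9;3;2;1;0;18;12;6;7;13;19;20],[::(11,6)]));
  ((8,2,1),([::0;10;11;9;8;7;1;2;3;4;5;6],[::]));
  ((8,2,2),([::5;6;7;8;2;3;4;10;9;11;12;1;0],[::]));
  ((8,2,3),([::5;11;9;8;7;6;0;13;12;10;4;3;2;1],[::]));
  ((8,2,4),([::6;4;2;1;0;14;5;11;10;9;8;7;13;12;3],[::]));
  ((8,2,5),([::12;14;0;15;9;8;7;13;3;2;1;11;10;4;5;6],[::]));
  ((8,2,6),([::6;7;9;10;16;0;1;2;8;14;3;4;15;13;12;11;5],[::]));
  ((8,2,7),([::15;13;7;9;8;14;2;1;0;17;5;6;12;11;10;16;4;3],[::]));
  ((8,2,8),([::16;15;14;12;13;11;5;18;17;4;10;9;3;2;8;7;1;0;6],[::]));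
  ((8,2,9),([::18;0;6;12;13;14;15;16;17;11;5;19;1;7;8;2;3;9;10;4],[::(6,6)]));
  ((8,2,10),([::1;0;2;8;10;4;5;11;12;6;7;13;19;20;14;15;9;3;18;17;16],[::(8,6)]));
  ((8,2,11),([::11;5;21;0;6;7;1;17;15;16;18;12;13;14;8;2;3;9;10;4;20;19],[::(6,6)]));
  ((8,2,12),([::0;1;3;2;8;14;15;9;10;16;22;20;21;4;5;11;17;18;12;6;7;13;19],[::(14,6)]));
  ((8,2,13),([::8;2;0;22;23;17;18;19;1;7;13;14;20;21;3;9;15;16;10;4;5;11;12;6],[::(7,6)]));
  ((8,2,14),([::16;10;8;14;20;19;13;11;17;18;12;6;0;24;5;4;23;22;21;15;9;3;2;1;7],[::(15,6)]));
  ((8,3,1),([::2;8;9;10;11;12;0;1;3;4;6;7;5],[::]));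
  ((8,3,2),([::4;3;2;1;7;9;8;10;11;12;0;13;5;6],[::]));
  ((8,3,3),([::12;13;11;9;0;1;2;3;4;10;8;7;6;5;14],[::]));
  ((8,3,4),([::9;15;14;8;6;12;13;11;10;0;1;2;3;4;5;7],[::]));
  ((8,3,5),([::9;11;13;14;3;2;8;7;1;0;16;15;4;5;6;12;10],[::]));
  ((8,3,6),([::15;13;14;12;6;8;2;3;9;10;11;5;4;16;17;0;1;7],[::]));
  ((8,3,7),([::9;15;2;0;17;18;5;4;3;16;10;11;12;13;14;1;7;8;6],[::]));
  ((8,3,8),([::15;13;7;6;0;19;1;2;16;17;3;4;18;12;14;8;9;10;11;5],[::]));
  ((8,3,9),([::5;11;12;6;0;20;1;2;3;9;15;13;7;8;14;16;17;18;19;4;10],[::(9,6)]));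
  ((8,3,10),([::1;7;6;0;21;20;4;10;9;3;19;17;15;16;18;2;8;14;13;12;11;5],[::(6,6)]));
  ((8,3,11),([::5;6;0;22;16;14;20;18;12;13;19;17;11;10;4;21;15;9;8;7;1;2;3],[::(17,6)]));
  ((8,3,12),([::20;18;19;13;15;21;22;23;17;16;10;4;5;11;12;6;0;1;7;9;3;2;8;14],[::(6,6)]));
  ((8,3,13),([::11;17;19;13;14;20;1;0;24;18;12;10;4;23;22;16;15;21;2;8;7;6;5;3;9],[::(17,6)]));
  ((8,3,14),([::9;15;17;11;13;19;20;14;12;18;24;4;10;16;22;23;3;2;8;7;6;5;25;0;1;21],[::(15,6)]));
  ((8,4,1),([::1;2;0;12;10;9;8;7;6;5;4;3;11;13],[::]));
  ((8,4,2),([::2;4;5;6;0;14;1;3;12;13;11;10;9;8;7],[::]));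
  ((8,4,3),([::14;15;13;11;10;12;6;0;1;2;3;9;8;7;5;4],[::]));
  ((8,4,4),([::9;10;11;13;2;1;3;4;5;7;8;14;12;6;0;16;15],[::]));
  ((8,4,5),([::6;4;2;3;9;8;14;15;13;12;11;5;7;1;0;17;16;10],[::]));
  ((8,4,6),([::18;0;1;7;9;10;16;15;2;4;17;11;12;13;14;8;6;5;3],[::]));
  ((8,4,7),([::12;6;4;10;8;2;1;0;19;18;17;11;5;3;9;7;13;14;15;16],[::]));
  ((8,4,8),([::17;16;18;20;14;8;2;0;15;9;10;11;12;13;19;4;5;6;7;1;3],[::]));
  ((8,4,9),([::21;15;9;3;1;7;8;2;4;10;11;5;6;12;13;14;16;0;20;19;18;17],[::(7,6)]));
  ((8,4,10),([::13;7;5;11;17;19;2;1;0;22;21;20;3;4;6;12;18;16;10;9;15;14;8],[::(12,6)]));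
  ((8,4,11),([::4;2;3;5;11;13;7;8;14;15;9;10;16;22;21;20;19;1;23;17;18;0;6;12],[::(11,6)]));
  ((8,4,12),([::9;15;21;23;24;5;7;8;14;20;19;13;12;18;17;11;10;16;22;3;2;4;6;0;1],[::(14,6)]));
  ((8,4,13),([::14;8;9;15;21;1;3;23;17;16;10;4;5;11;12;6;7;13;19;18;20;22;2;0;25;24],[::(11,6)]));
  ((8,4,14),([::6;0;21;15;17;23;25;19;20;26;5;4;2;8;7;1;22;16;18;24;3;9;10;11;12;13;14],[::(21,6)]));
  ((8,5,1),([::12;14;5;6;7;8;10;9;11;13;0;1;2;3;4],[::]));
  ((8,5,2),([::8;6;12;2;1;3;4;5;7;9;10;11;13;14;15;0],[::]));
  ((8,5,3),([::8;10;11;12;6;0;1;2;3;4;5;7;9;15;13;14;16],[::]));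
  ((8,5,4),([::3;5;11;17;0;2;4;6;7;8;9;10;16;15;14;12;13;1],[::]));
  ((8,5,5),([::10;8;2;1;7;5;3;9;11;12;13;14;15;16;17;4;6;0;18],[::]));
  ((8,5,6),([::4;5;7;8;6;0;18;12;13;19;1;3;2;16;17;11;10;9;15;14],[::]));
  ((8,5,7),([::20;0;2;1;7;9;3;4;5;6;12;18;16;15;14;8;10;11;17;19;13],[::]));
  ((8,5,8),([::11;13;14;16;0;1;17;15;9;8;7;6;12;10;4;5;21;20;18;2;3;19],[::]));
  ((8,5,9),([::17;11;10;16;22;1;7;9;8;6;5;4;3;2;19;13;12;18;20;14;15;21;0],[::(16,6)]));
  ((8,5,10),([::2;0;23;22;21;20;19;13;12;18;16;10;4;6;5;11;17;15;9;3;1;7;8;14],[::(14,6)]));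
  ((8,5,11),([::0;19;20;14;8;6;12;18;17;11;5;7;13;15;9;10;16;22;21;23;24;1;2;3;4],[::(12,6)]));
  ((8,5,12),([::16;22;24;18;12;13;19;21;15;17;23;3;4;10;9;11;5;6;7;8;14;20;0;25;1;2],[::(19,6)]));
  ((8,5,13),([::24;18;16;22;1;7;13;11;10;8;9;15;21;0;26;25;19;17;23;2;3;4;5;6;12;14;20],[::(20,6)]));
  ((8,5,14),([::20;26;27;25;3;9;15;16;18;24;2;1;0;22;21;23;17;19;13;7;8;14;12;6;5;11;10;4],[::(10,6)]));
  ((8,6,1),([::13;3;1;2;4;6;5;7;8;9;10;11;12;14;0;15],[::]));
  ((8,6,2),([::2;4;6;0;15;14;13;12;11;10;9;8;7;5;16;1;3],[::]));
  ((8,6,3),([::6;5;3;4;2;8;10;12;11;9;7;13;1;0;17;16;15;14],[::]));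
  ((8,6,4),([::9;7;13;0;17;18;12;11;10;8;6;4;5;3;2;1;14;15;16],[::]));
  ((8,6,5),([::19;1;15;13;7;9;8;2;3;4;10;11;12;14;16;17;18;0;6;5],[::]));
  ((8,6,6),([::6;7;9;15;13;14;16;1;3;4;5;20;0;19;18;12;11;10;8;2;17],[::]));
  ((8,6,7),([::6;7;5;4;2;3;1;17;18;12;10;16;0;21;20;19;13;11;9;15;14;8],[::]));
  ((8,6,8),([::22;16;10;9;15;21;19;13;11;17;18;20;14;12;6;8;7;5;4;3;2;1;0],[::]));
  ((8,6,9),([::19;18;12;6;8;14;20;21;22;0;23;1;2;3;4;10;16;17;15;9;7;13;11;5],[::(10,6)]));
  ((8,6,10),([::8;6;4;2;0;1;7;5;3;22;23;24;18;12;11;17;16;10;9;15;21;20;14;13;19],[::(15,6)]));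
  ((8,6,11),([::17;15;13;12;6;4;10;16;18;24;23;22;21;19;20;14;8;2;3;9;11;5;25;0;1;7],[::(7,6)]));
  ((8,6,12),([::12;6;8;14;16;15;9;7;13;19;20;26;5;11;10;4;2;1;3;24;25;0;21;22;23;17;18],[::(10,6)]));
  ((8,6,13),([::14;20;26;27;25;3;1;2;0;6;8;9;10;4;5;7;13;19;21;15;16;22;23;17;11;12;18;24],[::(17,6)]));
  ((8,6,14),([::24;23;0;1;2;3;5;28;22;20;14;8;6;4;10;16;17;11;12;18;19;13;7;9;15;21;27;25;26],[::(14,6)]));
  ((8,7,1),([::1;7;8;9;11;10;12;13;15;14;16;0;2;3;5;4;6],[::]));
  ((8,7,2),([::7;8;2;1;0;17;15;16;14;12;13;11;9;10;4;6;5;3],[::]));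
  ((8,7,3),([::7;9;15;2;4;10;8;6;5;3;1;0;18;17;16;14;13;12;11],[::]));
  ((8,7,4),([::6;12;11;17;15;1;19;13;14;16;18;0;2;3;4;5;7;8;9;10],[::]));
  ((8,7,5),([::6;0;19;18;12;14;15;16;17;2;4;3;1;20;5;7;13;11;10;9;8],[::]));
  ((8,7,6),([::0;20;18;2;8;14;16;17;15;9;10;11;12;13;19;21;1;7;6;5;3;4],[::]));
  ((8,7,7),([::1;18;12;14;15;16;17;19;21;22;5;7;13;11;10;9;8;2;0;6;4;3;20],[::]));
  ((8,7,8),([::14;20;18;0;23;17;19;21;22;16;15;9;7;8;2;1;3;5;6;12;13;11;10;4],[::]));
  ((8,7,9),([::13;7;9;15;14;8;6;12;11;5;3;22;23;24;0;1;20;21;19;17;18;16;10;4;2],[::(10,6)]));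
  ((8,7,10),([::11;5;6;12;18;24;4;10;16;14;8;7;13;15;17;19;20;22;21;23;25;0;1;2;3;9],[::(9,6)]));
  ((8,7,11),([::5;11;17;16;18;24;26;1;7;9;3;4;10;8;2;23;22;21;20;19;25;0;6;12;13;15;14],[::(6,6)]));
  ((8,7,12),([::18;24;22;16;10;11;9;3;25;19;20;26;27;21;15;17;23;1;0;2;4;6;5;7;8;14;13;12],[::(21,6)]));
  ((8,7,13),([::27;21;22;20;14;15;13;12;6;5;11;10;4;2;8;7;1;24;18;16;17;19;25;23;0;28;26;3;9],[::(7,6)]));
  ((8,7,14),([::3;4;5;6;7;13;14;8;9;15;21;27;25;19;20;18;12;10;16;22;24;0;28;26;2;1;29;23;17;11],[::(13,6)]));
  ((8,8,1),([::8;6;5;3;1;7;9;10;12;11;13;14;15;16;17;0;2;4],[::]));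
  ((8,8,2),([::18;1;7;9;15;17;0;2;3;4;5;6;8;10;11;12;13;14;16],[::]));
  ((8,8,3),([::14;12;13;15;17;19;5;6;4;3;2;16;18;0;1;7;8;9;11;10],[::]));
  ((8,8,4),([::20;19;4;3;1;2;0;15;14;8;6;5;7;9;10;12;13;11;17;16;18],[::]));
  ((8,8,5),([::12;14;15;16;18;20;4;6;5;7;8;10;9;3;2;1;17;11;13;19;21;0],[::]));
  ((8,8,6),([::4;21;19;17;0;2;8;14;13;12;11;10;9;3;5;6;7;1;22;20;18;16;15],[::]));
  ((8,8,7),([::5;11;12;14;15;13;7;1;2;8;10;16;18;17;19;20;21;23;22;0;6;4;3;9],[::]));
  ((8,8,8),([::0;1;3;2;4;6;7;8;14;12;10;16;15;9;11;5;24;18;20;21;22;23;17;19;13],[::]));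
  ((8,8,9),([::10;16;14;8;7;13;15;9;11;17;19;20;18;12;6;5;3;2;0;1;21;22;23;25;24;4],[::(12,6)]));
  ((8,8,10),([::12;18;24;3;4;6;8;2;0;1;26;20;19;25;23;17;16;22;21;15;14;13;11;5;7;9;10],[::(21,6)]));
  ((8,8,11),([::5;7;13;19;18;12;6;0;22;16;14;20;21;15;17;23;25;24;26;27;1;2;4;3;9;8;10;11],[::(18,6)]));
  ((8,8,12),([::6;8;10;11;13;19;20;14;12;18;24;1;2;4;27;28;0;23;17;16;22;21;15;9;7;5;3;26;25],[::(18,6)]));
  ((8,8,13),([::11;17;18;24;0;6;7;8;10;4;2;1;3;5;29;23;22;28;26;20;21;27;25;19;13;12;14;16;15;9],[::(24,6)]));
  ((8,8,14),([::11;5;7;13;15;9;3;4;10;12;6;8;14;16;17;23;22;21;19;25;0;1;2;27;28;26;20;18;24;30;29],[::(9,6)]));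
  ((8,9,1),([::10;11;5;7;9;8;6;4;3;2;0;1;18;17;16;14;12;13;15],[::]));
  ((8,9,2),([::17;19;18;16;2;0;14;15;13;12;11;9;10;8;6;7;5;4;3;1],[::]));
  ((8,9,3),([::12;14;13;15;17;11;5;7;8;6;4;2;3;1;0;20;19;18;16;10;9],[::]));
  ((8,9,4),([::21;20;0;2;8;10;12;6;4;5;7;1;3;9;11;13;14;15;16;17;18;19],[::]));
  ((8,9,5),([::22;1;0;17;16;18;12;11;9;10;8;14;15;13;7;5;6;4;2;3;20;21;19],[::]));
  ((8,9,6),([::0;18;20;2;3;1;7;5;6;12;13;15;14;16;17;19;21;23;22;4;10;11;9;8],[::]));
  ((8,9,7),([::14;15;17;11;5;24;23;0;2;21;20;22;16;18;19;13;12;10;9;8;6;4;3;1;7],[::]));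
  ((8,9,8),([::9;3;2;0;6;4;5;11;17;16;18;12;10;8;7;1;21;23;25;24;22;20;19;13;14;15],[::]));
  ((8,9,9),([::23;17;15;21;20;14;16;22;1;7;5;6;8;9;11;13;12;10;4;3;2;0;26;24;18;19;25],[::(20,6)]));
  ((8,9,10),([::26;24;23;1;27;25;19;17;11;10;16;15;9;8;14;13;7;5;3;4;2;0;22;21;20;18;12;6],[::(12,6)]));
  ((8,9,11),([::17;11;5;6;0;28;26;27;21;23;25;24;22;20;19;13;12;18;16;10;4;2;3;1;7;9;15;14;8],[::(14,6)]));
  ((8,9,12),([::23;29;0;1;2;4;6;12;11;17;16;10;8;14;13;15;9;7;5;3;27;21;22;28;26;20;18;24;25;19],[::(24,6)]));
  ((8,9,13),([::18;12;11;17;19;13;7;8;14;15;9;10;16;22;21;27;29;4;6;5;3;1;2;0;25;23;24;30;28;26;20],[::(14,6)]));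
  ((8,9,14),([::19;25;23;17;18;24;26;20;21;27;1;7;6;0;30;29;31;5;11;10;8;9;15;13;12;14;16;22;28;2;4;3],[::(23,6)]));
  ((8,10,1),([::12;14;16;17;15;13;7;9;11;10;8;6;5;3;4;2;1;0;19;18],[::(14,2)]));
  ((8,10,2),([::13;12;10;4;5;3;1;2;0;20;19;18;16;14;15;17;11;9;7;8;6],[::(11,2)]));
  ((8,10,3),([::1;3;5;6;7;8;14;20;0;2;4;10;9;11;12;13;15;16;18;17;19;21],[::(3,2)]));
  ((8,10,4),([::5;3;1;18;16;10;12;13;15;14;20;19;21;22;0;2;4;6;7;8;9;11;17],[::(4,2)]));
  ((8,10,5),([::23;22;20;19;21;3;9;10;12;6;5;4;2;0;1;7;8;14;16;18;17;15;13;11],[::(21,2)]));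
  ((8,10,6),([::14;20;22;23;0;1;24;5;6;7;8;2;4;3;9;11;12;10;16;18;17;15;13;19;21],[::(21,2)]));
  ((8,10,7),([::16;15;9;11;10;4;5;6;0;24;25;23;21;19;17;18;20;22;2;3;1;7;13;12;14;8],[::(20,2)]));
  ((8,10,8),([::10;16;22;24;25;23;21;20;19;18;17;15;14;12;6;4;2;8;9;3;5;11;13;7;1;26;0],[::(23,2)]));
  ((8,10,9),([::7;9;11;12;10;8;2;0;1;3;4;6;5;27;26;20;14;13;15;21;22;16;18;24;25;19;17;23],[::(9,2);(20,6)]));
  ((8,10,10),([::13;19;17;11;12;18;20;21;15;9;3;4;10;16;14;8;7;6;5;28;1;2;0;27;25;23;22;24;26],[::(26,2);(14,6)]));
  ((8,10,11),([::6;12;10;8;7;9;15;17;23;25;19;18;24;26;20;21;27;3;5;11;13;14;16;22;28;29;0;1;2;4],[::(4,2);(22,6)]));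
  ((8,10,12),([::5;11;12;6;0;2;8;7;1;26;27;25;23;21;15;14;13;19;17;16;18;20;22;24;30;28;29;4;10;9;3],[::(24,2);(7,6)]));
  ((8,10,13),([::3;2;1;0;26;20;19;25;31;30;24;18;12;10;8;6;4;5;7;9;11;13;14;16;22;28;27;21;15;17;23;29],[::(11,2);(25,6)]));
  ((8,10,14),([::0;31;25;19;21;27;29;23;24;30;28;22;20;26;32;5;6;4;10;12;13;14;15;16;18;17;11;9;3;1;7;8;2],[::(11,2);(25,6)]));
  ((8,11,1),([::0;1;2;8;6;4;3;5;7;9;11;10;12;13;14;15;17;19;20;18;16],[::(17,2)]));
  ((8,11,2),([::21;15;17;11;12;13;14;16;18;19;20;0;1;2;4;6;8;10;9;7;5;3],[::(5,2)]));
  ((8,11,3),([::18;1;22;5;3;20;19;21;0;2;4;6;7;9;8;10;11;12;13;14;16;17;15],[::(16,2)]));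
  ((8,11,4),([::18;12;10;11;13;7;9;8;2;0;22;20;14;15;16;17;19;21;23;1;3;4;5;6],[::(2,2)]));
  ((8,11,5),([::14;16;17;15;13;12;10;11;9;7;6;4;23;22;24;5;3;1;0;19;18;20;21;2;8],[::(15,2)]));
  ((8,11,6),([::6;8;7;5;4;3;23;21;15;14;16;10;9;11;17;19;13;12;18;20;22;24;25;1;2;0],[::(22,2)]));
  ((8,11,7),([::10;12;14;20;22;16;17;18;19;21;15;13;11;5;4;2;1;7;6;8;9;3;24;26;0;25;23],[::(14,2)]));
  ((8,11,8),([::18;16;10;8;6;0;2;1;3;4;26;27;5;7;9;15;21;22;24;25;23;17;19;20;14;13;11;12],[::(8,2)]));
  ((8,11,9),([::7;13;15;9;8;14;20;22;28;1;2;0;27;25;26;24;23;21;19;17;11;10;16;18;12;6;5;4;3],[::(22,2);(13,6)]));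
  ((8,11,10),([::25;27;3;9;11;5;4;10;12;6;0;28;29;1;7;8;2;26;24;23;22;20;18;17;16;14;15;13;19;21],[::(20,2);(6,6)]));
  ((8,11,11),([::17;15;9;7;13;12;6;5;11;10;4;29;0;2;1;3;28;30;24;22;23;21;20;26;27;25;19;18;16;14;8],[::(17,2);(10,6)]));
  ((8,11,12),([::19;25;23;17;11;9;10;4;3;1;7;8;2;0;30;28;29;31;5;6;12;13;15;14;16;22;24;18;20;26;27;21],[::(30,2);(22,6)]));
  ((8,11,13),([::7;5;3;2;4;6;8;10;12;18;16;15;9;11;17;23;29;27;21;22;28;1;0;32;26;24;30;31;25;19;20;14;13],[::(4,2);(27,6)]));
  ((8,11,14),([::29;31;25;24;26;32;30;28;27;33;5;6;12;18;19;21;23;22;20;14;8;7;13;15;9;3;1;0;2;4;10;16;17;11],[::(22,2);(12,6)]));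
  ((9,1,1),([::8;9;10;11;0;1;7;6;5;4;2;3],[::(9,1)]));
  ((9,1,2),([::12;5;6;7;8;9;10;11;4;3;2;0;1],[::(6,1)]));
  ((9,1,3),([::11;10;2;3;1;9;8;7;6;5;4;12;13;0],[::(5,1)]));
  ((9,1,4),([::10;11;2;4;5;6;7;1;0;14;13;12;3;9;8],[::(11,1)]));
  ((9,1,5),([::15;14;8;2;0;1;7;13;12;11;10;9;3;4;5;6],[::(15,1)]));
  ((9,1,6),([::6;4;5;11;12;1;0;16;15;14;8;7;13;2;3;9;10],[::(3,1)]));
  ((9,1,7),([::9;15;14;13;12;0;1;7;8;6;5;11;17;16;10;4;3;2],[::(1,1)]));
  ((9,1,8),([::17;11;13;12;18;0;6;5;4;3;9;10;16;15;14;1;7;8;2],[::(10,1)]));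
  ((9,1,9),([::2;1;15;9;8;14;0;19;18;12;11;17;16;10;4;3;5;6;7;13],[::(2,1);(13,6)]));
  ((9,1,10),([::12;6;7;13;11;5;4;10;9;3;18;19;20;0;1;16;15;14;8;2;17],[::(16,1);(8,6)]));
  ((9,1,11),([::8;2;3;9;15;16;10;4;5;11;17;18;19;20;21;0;6;12;14;13;7;1],[::(21,1);(7,6)]));
  ((9,1,12),([::14;20;21;15;9;3;4;5;6;7;13;19;18;12;11;17;0;1;2;8;10;16;22],[::(1,1);(16,6)]));
  ((9,1,13),([::22;21;20;2;3;9;15;14;8;7;6;12;18;16;10;4;5;11;17;23;0;1;19;13],[::(3,1);(14,6)]));
  ((9,1,14),([::13;7;6;12;18;17;11;5;4;10;16;22;23;24;0;19;21;15;9;8;14;20;1;2;3],[::(3,1);(12,6)]));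
  ((9,2,1),([::4;11;12;10;9;8;7;6;5;3;2;1;0],[::(10,1)]));
  ((9,2,2),([::5;6;7;8;10;9;11;3;4;12;13;0;1;2],[::(7,1)]));
  ((9,2,3),([::7;9;3;2;1;0;14;8;6;5;4;10;11;12;13],[::(3,1)]));
  ((9,2,4),([::1;15;14;8;9;10;0;2;3;4;5;11;12;13;7;6],[::(4,1)]));
  ((9,2,5),([::3;5;6;7;8;14;13;2;4;15;9;10;11;12;1;0;16],[::(6,1)]));
  ((9,2,6),([::6;8;9;10;12;11;5;17;0;1;7;13;14;2;3;4;16;15],[::(14,1)]));
  ((9,2,7),([::11;10;8;9;3;2;1;7;13;12;6;0;18;5;4;17;16;14;15],[::(17,1)]));
  ((9,2,8),([::1;2;0;6;7;8;9;10;16;15;14;13;19;5;3;17;11;12;18;4],[::(10,1)]));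
  ((9,2,9),([::13;7;5;11;12;6;4;10;16;17;18;19;20;14;8;9;15;0;1;2;3],[::(3,1);(10,6)]));
  ((9,2,10),([::12;6;5;11;13;7;1;21;0;16;15;14;8;2;3;9;10;4;20;19;18;17],[::(16,1);(7,6)]));
  ((9,2,11),([::7;13;12;6;8;14;20;21;19;18;17;11;5;4;10;16;22;0;1;2;3;9;15],[::(2,1);(11,6)]));
  ((9,2,12),([::16;10;9;15;14;8;7;13;12;6;4;3;21;20;2;1;19;18;0;22;23;17;11;5],[::(4,1);(11,6)]));
  ((9,2,13),([::14;15;21;2;8;10;4;3;9;11;5;24;0;6;12;13;7;1;20;19;18;17;16;22;23],[::(15,1);(7,6)]));
  ((9,2,14),([::1;25;5;11;17;18;12;6;0;2;3;9;15;16;10;4;24;23;22;21;20;19;13;7;8;14],[::(24,1);(13,6)]));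
  ((9,3,1),([::8;2;0;1;13;12;11;10;9;7;6;5;4;3],[::(13,1)]));
  ((9,3,2),([::4;2;8;7;6;5;3;9;10;11;12;13;14;1;0],[::(11,1)]));
  ((9,3,3),([::4;3;1;15;0;2;12;11;10;9;8;14;13;7;6;5],[::(4,1)]));
  ((9,3,4),([::5;4;15;13;12;11;10;9;3;14;16;0;1;2;8;6;7],[::(12,1)]));
  ((9,3,5),([::2;1;13;11;12;0;17;15;16;14;8;7;6;5;4;10;9;3],[::(2,1)]));
  ((9,3,6),([::4;3;1;14;8;7;9;10;11;5;6;12;13;0;2;15;16;17;18],[::(4,1)]));
  ((9,3,7),([::0;6;8;2;1;15;14;13;12;11;10;4;5;19;18;16;17;3;9;7],[::(14,1)]));
  ((9,3,8),([::19;4;2;1;3;18;17;16;15;0;6;12;13;14;20;5;11;10;9;7;8],[::(14,1)]));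
  ((9,3,9),([::3;9;10;4;20;18;17;19;21;5;11;12;13;14;15;16;0;6;7;1;2;8],[::(14,1);(6,6)]));
  ((9,3,10),([::2;0;6;8;14;15;9;10;16;17;11;12;18;19;13;7;1;3;4;5;22;21;20],[::(22,1);(13,6)]));
  ((9,3,11),([::16;15;21;20;22;23;5;11;17;18;19;13;14;12;6;0;1;7;8;2;4;10;9;3],[::(23,1);(6,6)]));
  ((9,3,12),([::24;22;21;15;9;8;7;6;5;11;17;23;0;19;13;14;20;1;2;3;4;10;16;18;12],[::(3,1);(16,6)]));
  ((9,3,13),([::18;19;20;21;23;17;16;15;9;3;4;10;12;6;0;1;7;13;14;8;2;22;24;25;5;11],[::(16,1);(9,6)]));
  ((9,3,14),([::5;6;7;8;2;23;17;19;25;4;3;9;10;11;12;18;24;26;20;14;13;15;21;0;1;22;16],[::(10,1);(21,6)]));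
  ((9,4,1),([::7;5;4;3;2;0;1;14;13;12;6;8;9;10;11],[::(4,1)]));
  ((9,4,2),([::8;6;4;5;7;13;12;11;10;9;3;2;1;0;14;15],[::(3,1)]));
  ((9,4,3),([::12;1;0;6;5;7;8;9;10;11;13;14;16;15;4;2;3],[::(9,1)]));
  ((9,4,4),([::14;2;1;3;4;6;7;8;9;10;16;15;13;11;12;0;17;5],[::(7,1)]));
  ((9,4,5),([::18;1;3;4;10;9;8;2;0;17;16;15;14;13;7;6;12;11;5],[::(14,1)]));
  ((9,4,6),([::5;19;1;2;4;18;0;6;7;13;12;11;10;8;9;3;17;16;15;14],[::(16,1)]));
  ((9,4,7),([::18;17;16;1;0;2;3;4;5;11;10;8;14;20;19;13;15;9;7;6;12],[::(5,1)]));
  ((9,4,8),([::6;4;5;7;8;9;10;12;11;17;1;0;16;18;2;3;19;13;14;20;21;15],[::(8,1)]));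
  ((9,4,9),([::5;4;6;7;8;9;3;2;1;0;17;11;13;19;18;12;10;16;22;20;14;15;21],[::(1,1);(16,6)]));
  ((9,4,10),([::18;16;10;9;15;14;8;7;13;12;6;5;23;0;2;20;21;22;4;3;1;19;17;11],[::(6,1);(12,6)]));
  ((9,4,11),([::16;10;12;18;24;22;20;14;13;19;0;1;2;3;4;5;11;17;23;21;15;9;8;7;6],[::(5,1);(16,6)]));
  ((9,4,12),([::13;14;20;0;24;18;19;25;1;21;15;17;23;3;4;5;6;12;11;10;9;7;8;2;22;16],[::(14,1);(20,6)]));
  ((9,4,13),([::1;3;24;26;5;11;17;16;10;4;25;0;2;23;22;21;20;19;18;12;6;7;13;14;8;9;15],[::(19,1);(11,6)]));
  ((9,4,14),([::7;6;8;9;15;21;20;14;13;19;25;26;4;2;3;1;0;27;5;11;17;23;22;16;10;12;18;24],[::(26,1);(18,6)]));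
  ((9,5,1),([::13;15;14;0;1;2;12;11;9;10;8;7;6;5;3;4],[::(12,1)]));
  ((9,5,2),([::12;6;8;9;10;11;13;14;15;16;1;7;5;4;3;2;0],[::(15,1)]));
  ((9,5,3),([::4;5;7;8;6;0;1;3;2;14;12;13;15;16;17;11;10;9],[::(11,1)]));
  ((9,5,4),([::2;8;10;12;11;9;3;4;5;18;1;0;17;16;15;14;13;7;6],[::(17,1)]));
  ((9,5,5),([::9;7;6;12;18;16;17;15;13;19;0;1;2;3;4;5;11;10;8;14],[::(5,1)]));
  ((9,5,6),([::10;4;2;3;9;11;17;15;16;18;19;20;0;1;7;5;6;12;13;14;8],[::(20,1)]));
  ((9,5,7),([::9;8;6;7;5;4;20;18;17;1;21;15;14;13;19;3;2;0;16;10;11;12],[::(5,1)]));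
  ((9,5,8),([::0;1;22;5;11;13;12;18;17;19;20;21;4;6;7;8;2;3;9;15;14;16;10],[::(21,1)]));
  ((9,5,9),([::13;7;1;0;6;12;10;4;2;3;9;11;5;23;22;21;20;18;19;17;16;15;14;8],[::(22,1);(9,6)]));
  ((9,5,10),([::6;12;18;17;11;9;15;16;10;4;5;7;13;19;20;21;22;24;23;0;1;3;2;8;14],[::(22,1);(13,6)]));
  ((9,5,11),([::11;10;9;8;2;0;25;5;6;7;1;3;4;24;18;12;14;20;19;13;15;21;23;17;16;22],[::(10,1);(19,6)]));
  ((9,5,12),([::21;15;16;22;20;14;12;18;24;3;1;26;0;2;23;17;11;10;9;8;7;6;5;4;25;19;13],[::(5,1);(17,6)]));
  ((9,5,13),([::22;16;15;14;12;11;10;9;8;6;0;27;21;20;26;4;2;24;18;17;23;1;7;5;3;25;19;13],[::(9,1);(22,6)]));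
  ((9,5,14),([::9;15;16;10;12;18;19;25;27;0;23;24;1;28;22;21;20;26;3;4;2;8;14;13;7;6;5;11;17],[::(19,1);(13,6)]));
  ((9,6,1),([::0;15;9;7;8;6;5;4;3;2;1;16;14;13;12;10;11],[::(6,1)]));
  ((9,6,2),([::2;0;6;12;13;14;16;15;17;1;3;4;5;7;8;9;10;11],[::(14,1)]));
  ((9,6,3),([::16;17;15;13;7;9;11;10;8;14;12;18;0;1;2;3;4;5;6],[::(1,1)]));
  ((9,6,4),([::3;4;5;11;13;14;16;15;17;18;0;19;1;7;6;12;10;9;8;2],[::(14,1)]));
  ((9,6,5),([::14;8;6;12;11;17;15;13;19;18;16;10;9;7;5;4;3;2;1;0;20],[::(4,1)]));
  ((9,6,6),([::2;4;10;9;15;13;19;20;21;0;1;3;5;11;12;6;7;8;14;16;18;17],[::(20,1)]));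
  ((9,6,7),([::16;10;4;5;3;20;19;17;18;12;13;11;9;15;14;8;7;6;0;2;1;22;21],[::(20,1)]));
  ((9,6,8),([::6;8;2;0;18;19;13;15;16;22;21;20;14;12;11;10;9;3;4;5;7;1;23;17],[::(12,1)]));
  ((9,6,9),([::3;9;10;4;6;12;13;19;20;21;22;23;0;2;8;7;1;24;5;11;17;18;16;14;15],[::(20,1);(7,6)]));
  ((9,6,10),([::16;10;11;17;15;9;7;5;4;3;23;24;0;25;1;2;22;21;20;14;8;6;12;18;19;13],[::(4,1);(14,6)]));
  ((9,6,11),([::4;10;12;6;7;13;19;17;23;22;21;20;18;24;25;26;5;11;9;3;1;0;2;8;14;15;16],[::(25,1);(9,6)]));
  ((9,6,12),([::22;16;15;13;19;25;27;21;20;26;0;1;23;17;18;24;2;3;4;5;11;9;10;8;14;12;6;7],[::(4,1);(22,6)]));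
  ((9,6,13),([::26;20;18;24;23;17;11;12;10;9;7;1;0;6;5;28;27;25;19;13;15;21;22;16;14;8;2;3;4],[::(28,1);(21,6)]));
  ((9,6,14),([::22;16;14;12;11;5;29;1;2;8;7;6;0;28;4;10;9;3;27;26;20;19;25;24;18;17;23;21;15;13],[::(12,1);(21,6)]));
  ((9,7,1),([::14;16;17;0;6;4;2;1;3;5;7;8;9;10;11;12;13;15],[::(10,1)]));
  ((9,7,2),([::11;12;14;13;0;17;18;16;15;2;1;3;4;5;6;8;10;9;7],[::(12,1)]));
  ((9,7,3),([::8;6;12;10;4;2;1;0;19;18;17;16;15;14;13;11;9;3;5;7],[::(2,1)]));
  ((9,7,4),([::16;15;14;20;18;17;11;12;10;9;8;6;7;13;19;0;1;3;5;4;2],[::(1,1)]));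
  ((9,7,5),([::6;0;2;3;9;7;5;4;20;18;19;21;1;17;16;15;14;8;10;11;12;13],[::(16,1)]));
  ((9,7,6),([::1;3;20;19;17;11;12;18;16;14;13;15;21;22;5;4;2;0;6;7;8;9;10],[::(10,1)]));
  ((9,7,7),([::8;7;6;0;2;1;23;21;19;18;12;11;17;16;10;9;15;13;14;20;22;4;5;3],[::(8,1)]));
  ((9,7,8),([::23;24;22;3;1;0;19;17;11;12;13;15;9;10;16;18;20;14;8;7;6;5;4;2;21],[::(5,1)]));
  ((9,7,9),([::22;23;3;9;8;2;1;7;6;0;24;25;19;17;15;21;20;18;16;14;13;12;10;4;5;11],[::(14,1);(6,6)]));
  ((9,7,10),([::24;3;5;26;25;0;1;22;16;17;23;2;4;6;7;9;8;10;11;12;18;19;13;15;21;20;14],[::(12,1);(18,6)]));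
  ((9,7,11),([::12;6;5;11;9;3;4;10;8;2;0;22;23;24;26;20;21;15;14;13;7;1;27;25;19;18;16;17],[::(14,1);(7,6)]));
  ((9,7,12),([::5;11;13;14;12;10;4;27;26;20;22;16;17;18;19;25;24;23;21;15;9;3;2;8;6;0;28;1;7],[::(27,1);(6,6)]));
  ((9,7,13),([::10;16;22;28;4;2;26;20;19;25;27;21;23;29;1;0;24;18;12;13;14;15;17;11;9;8;7;6;5;3],[::(9,1);(24,6)]));
  ((9,7,14),([::6;4;5;3;9;10;12;11;17;23;25;19;13;7;8;2;1;0;30;29;27;21;15;14;20;26;24;18;16;22;28],[::(30,1);(22,6)]));
  ((9,8,1),([::3;2;0;18;17;15;16;14;12;13;11;10;9;8;6;4;5;7;1],[::(10,1)]));
  ((9,8,2),([::19;13;12;11;9;7;5;6;8;10;4;3;1;2;0;18;17;16;15;14],[::(12,1)]));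
  ((9,8,3),([::10;9;8;2;1;0;19;20;18;17;11;13;15;16;14;12;6;7;5;3;4],[::(1,1)]));
  ((9,8,4),([::0;2;18;16;15;9;8;7;5;6;4;3;1;21;19;20;14;13;12;10;11;17],[::(9,1)]));
  ((9,8,5),([::21;20;19;18;17;15;13;7;1;3;4;6;8;9;10;16;14;12;11;5;22;0;2],[::(18,1)]));
  ((9,8,6),([::20;2;8;9;10;11;17;19;21;15;13;14;12;18;16;22;0;23;1;3;4;5;6;7],[::(10,1)]));
  ((9,8,7),([::6;0;1;7;5;4;23;21;15;13;12;14;16;17;19;20;18;24;22;3;2;8;9;10;11],[::(10,1)]));
  ((9,8,8),([::20;21;23;25;0;1;7;9;8;2;22;24;4;10;16;14;15;17;18;19;13;11;12;6;5;3],[::(21,1)]));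
  ((9,8,9),([::8;7;5;4;3;9;10;11;17;19;13;15;21;23;24;25;26;1;2;0;6;12;18;20;14;16;22],[::(25,1);(17,6)]));
  ((9,8,10),([::7;9;15;21;27;0;26;4;5;6;8;14;16;10;12;18;17;11;13;19;20;22;23;24;25;3;1;2],[::(6,1);(14,6)]));
  ((9,8,11),([::18;12;11;17;15;9;3;26;28;0;27;4;2;1;24;25;23;22;21;20;19;13;7;5;6;8;14;16;10],[::(21,1);(14,6)]));
  ((9,8,12),([::10;12;18;19;13;14;20;26;2;4;6;7;8;9;11;17;23;25;24;22;16;15;21;27;3;5;29;28;0;1],[::(8,1);(18,6)]));
  ((9,8,13),([::0;1;30;29;4;5;7;13;19;21;22;20;26;28;3;2;27;25;24;23;17;11;10;16;18;12;6;8;14;15;9],[::(5,1);(13,6)]));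
  ((9,8,14),([::6;7;5;4;3;2;1;31;0;30;29;23;17;16;22;28;26;20;14;8;10;12;18;24;25;19;13;11;9;15;21;27],[::(2,1);(22,6)]));
  ((9,9,1),([::12;10;16;18;19;0;2;1;3;5;4;6;7;8;9;11;13;14;15;17],[::(19,1)]));
  ((9,9,2),([::18;19;17;11;9;8;6;7;5;3;4;2;1;20;0;15;16;14;13;12;10],[::(2,1)]));
  ((9,9,3),([::15;17;19;20;21;1;2;0;6;8;7;5;4;3;9;10;11;13;14;12;18;16],[::(20,1)]));
  ((9,9,4),([::6;12;14;16;10;11;17;15;13;19;18;20;22;21;0;1;2;3;4;5;7;9;8],[::(2,1)]));
  ((9,9,5),([::3;1;0;18;20;19;13;11;10;9;7;5;4;2;8;6;12;14;15;16;17;23;21;22],[::(1,1)]));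
  ((9,9,6),([::14;15;21;23;22;3;5;11;10;8;9;7;1;24;0;2;4;6;12;13;19;20;18;17;16],[::(13,1)]));
  ((9,9,7),([::22;24;23;3;4;2;0;1;25;5;6;7;8;10;16;14;12;18;17;11;9;15;13;19;20;21],[::(20,1)]));
  ((9,9,8),([::17;19;18;16;14;20;22;24;26;25;0;21;15;13;12;6;7;1;3;4;5;11;10;9;8;2;23],[::(13,1)]));
  ((9,9,9),([::15;9;8;7;6;0;1;27;5;4;2;3;25;26;24;22;23;21;19;13;11;17;16;10;12;18;20;14],[::(9,1);(15,6)]));
  ((9,9,10),([::23;22;21;20;18;19;17;15;9;10;16;14;8;7;13;11;5;4;2;25;24;1;3;26;28;27;0;6;12],[::(23,1);(11,6)]));
  ((9,9,11),([::13;14;20;21;15;16;22;28;0;24;18;19;25;23;17;11;9;7;8;10;12;6;5;4;3;1;29;27;26;2],[::(6,1);(20,6)]));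
  ((9,9,12),([::30;28;27;26;20;19;13;12;6;0;29;4;10;11;5;3;9;7;1;2;8;14;15;17;16;18;24;22;21;23;25],[::(27,1);(7,6)]));
  ((9,9,13),([::15;9;3;1;31;30;29;23;22;21;20;19;13;7;5;11;17;18;12;10;16;14;8;6;0;26;24;25;27;28;2;4],[::(23,1);(14,6)]));
  ((9,9,14),([::15;9;3;30;24;22;21;20;18;12;6;4;5;7;13;19;17;11;10;16;14;8;2;1;0;27;28;26;25;23;29;31;32],[::(21,1);(13,6)]));
  ((9,10,1),([::7;5;4;2;3;1;20;19;0;6;8;10;9;11;12;14;13;15;16;17;18],[::(17,1);(7,2)]));
  ((9,10,2),([::9;11;10;8;7;6;5;4;3;2;0;16;18;20;19;21;1;17;15;13;12;14],[::(3,1);(10,2)]));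
  ((9,10,3),([::1;0;6;4;3;2;19;20;21;22;5;7;8;9;11;13;15;17;18;16;14;12;10],[::(9,1);(13,2)]));
  ((9,10,4),([::4;5;3;2;0;22;20;21;15;14;16;18;17;23;1;19;13;12;11;10;8;6;7;9],[::(13,1);(8,2)]));
  ((9,10,5),([::8;6;12;14;13;19;18;17;15;16;10;11;5;7;9;3;4;2;1;24;0;23;21;20;22],[::(2,1);(22,2)]));
  ((9,10,6),([::7;5;4;2;3;1;21;19;17;11;12;6;8;14;13;15;9;10;16;18;20;22;23;24;25;0],[::(5,1);(18,2)]));
  ((9,10,7),([::21;22;1;0;26;24;3;9;11;10;8;2;23;25;4;6;5;7;13;12;14;15;16;18;20;19;17],[::(22,1);(18,2)]));
  ((9,10,8),([::10;9;3;5;4;26;25;23;21;15;13;14;12;11;17;16;18;19;20;22;24;2;8;6;0;27;1;7],[::(10,1);(24,2)]));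
  ((9,10,9),([::5;11;10;4;6;12;18;20;19;17;16;14;8;7;13;15;9;3;2;1;24;26;28;0;27;25;23;22;21],[::(2,1);(19,2);(9,6)]));
  ((9,10,10),([::20;22;23;29;0;28;27;26;24;25;1;2;4;6;8;14;13;7;9;15;21;19;18;12;10;16;17;11;5;3],[::(23,1);(5,2);(13,6)]));
  ((9,10,11),([::9;10;4;2;3;5;30;1;7;8;6;0;29;28;27;26;20;18;24;23;17;15;21;22;16;14;12;11;13;19;25],[::(27,1);(13,2);(21,6)]));
  ((9,10,12),([::10;9;15;21;22;16;14;20;19;13;7;8;6;12;18;17;11;5;4;3;1;27;25;23;24;26;28;2;0;30;29;31],[::(4,1);(27,2);(17,6)]));
  ((9,10,13),([::18;12;13;19;17;11;9;7;1;28;27;25;26;24;23;21;15;14;20;22;16;10;8;2;0;6;5;32;31;29;30;3;4],[::(28,1);(10,2);(17,6)]));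
  ((9,10,14),([::10;8;6;7;9;11;12;14;20;21;15;17;23;22;16;18;24;26;28;0;1;29;30;2;3;31;32;4;5;33;27;25;19;13],[::(12,1);(8,2);(20,6)]));
  ((9,11,1),([::17;15;13;11;10;9;7;8;6;12;14;16;18;19;20;21;0;1;3;5;4;2],[::(19,1);(3,2)]));
  ((9,11,2),([::17;15;9;8;6;7;13;11;10;12;14;16;18;19;20;22;21;0;2;1;3;4;5],[::(4,1);(16,2)]));
  ((9,11,3),([::19;17;15;16;18;20;21;3;1;23;22;4;2;0;6;5;7;8;9;10;11;13;12;14],[::(21,1);(18,2)]));
  ((9,11,4),([::16;18;17;19;20;14;15;21;22;23;4;6;12;13;11;9;10;8;7;5;3;1;24;0;2],[::(22,1);(6,2)]));
  ((9,11,5),([::7;8;9;11;17;19;20;21;23;25;5;3;1;0;6;4;2;22;24;18;16;15;14;13;12;10],[::(9,1);(11,2)]));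
  ((9,11,6),([::15;17;19;18;16;14;13;11;9;7;8;10;12;6;5;4;25;24;3;1;2;23;22;20;26;0;21],[::(5,1);(16,2)]));
  ((9,11,7),([::1;2;8;7;5;6;4;3;9;11;17;19;20;22;16;18;24;23;25;26;0;27;21;15;13;14;12;10],[::(2,1);(11,2)]));
  ((9,11,8),([::20;21;19;18;17;15;13;14;8;10;16;22;23;24;25;2;0;1;3;26;28;5;7;9;11;12;6;4;27],[::(25,1);(6,2)]));
  ((9,11,9),([::4;6;12;10;16;17;23;25;19;18;24;26;20;22;28;29;0;2;1;3;5;7;8;9;11;13;14;15;21;27],[::(29,1);(5,2);(23,6)]));
  ((9,11,10),([::29;28;27;21;19;17;11;10;16;14;8;9;15;13;7;1;3;4;2;0;30;5;6;12;18;20;22;23;25;26;24],[::(28,1);(19,2);(12,6)]));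
  ((9,11,11),([::0;1;27;21;19;17;18;16;15;13;11;5;4;2;3;29;23;25;31;30;24;22;28;26;20;14;12;6;7;8;10;9],[::(5,1);(13,2);(26,6)]));
  ((9,11,12),([::27;29;28;26;32;30;3;4;5;11;17;19;21;23;24;25;31;0;1;2;8;14;16;10;9;15;13;7;6;12;18;20;22],[::(24,1);(22,2);(12,6)]));
  ((9,11,13),([::28;26;24;18;12;6;7;13;14;8;2;4;10;11;5;3;9;15;21;19;20;22;16;17;23;25;27;29;31;30;32;33;0;1],[::(1,1);(25,2);(8,6)]));
  ((9,11,14),([::24;18;20;26;25;19;21;27;28;29;31;32;30;1;3;2;8;7;9;10;4;33;34;5;11;13;15;17;23;22;16;14;12;6;0],[::(29,1);(13,2);(22,6)]))].

Definition base_case_ok (t : (nat * nat * nat) * (seq nat * seq (nat * nat))) : bool :=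
  let: ((a, b, c), (p, bs)) := t in
  [&& perm_eq p (iota 0 (a + b + c + 1)),
      perm_eq (path_lengths (a + b + c + 1) p) (L126 a b c),
      blocks_at 6 (a + b + c + 1) p bs & map snd bs == block_widths a b c].

Lemma base_cases_ok : all base_case_ok base_cases.
Proof. by vm_compute. Qed.

Lemma base_cases_complete :
  all (fun a => all (fun b => all (fun c => admissible a b c ==> ((a, b, c) \in map fst base_cases))
    (iota 1 14)) (iota 1 11)) (iota 1 9).
Proof. by vm_compute. Qed.

Lemma realisable_base a b c :
  0 < a <= 9 -> 0 < b <= 11 -> 0 < c <= 14 -> admissible a b c -> realisable a b c.
Proof.
move=> a_box b_box c_box abc_adm.
have /mapP [[t [p bs]] t_base /= t_abc] : (a, b, c) \in map fst base_cases.
  move/allP/(_ a): base_cases_complete; rewrite mem_iota => /(_ a_box).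
  move/allP/(_ b); rewrite mem_iota => /(_ b_box).
  by move/allP/(_ c); rewrite mem_iota abc_adm => /(_ c_box).
have := allP base_cases_ok _ t_base; rewrite -t_abc => /and4P [p_ham p_len p_blocks /eqP bs_widths].
by exists p, bs.
Qed.

Lemma realisable_grow1 a b c :
  9 <= a -> 12 <= a + b + c + 1 -> realisable a b c -> realisable (a + 1) b c.
Proof.
move=> a_ge9 v_ge12 abc_real; rewrite -[b]addn0 -[c]addn0.
apply: (realisable_grow (k := 1)) abc_real => //; first by rewrite /block_widths a_ge9.
by apply: block_widths_grow; lia.
Qed.

Lemma realisable_grow2 a b c :
  10 <= b -> 12 <= a + b + c + 1 -> realisable a b c -> realisable a (b + 2) c.
Proof.
move=> b_ge10 v_ge12 abc_real; rewrite -[a]addn0 -[c]addn0.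
apply: (realisable_grow (k := 2)) abc_real => //.
  by rewrite /block_widths b_ge10; case: (9 <= a).
by apply: block_widths_grow; lia.
Qed.

Lemma realisable_grow6 a b c :
  9 <= c -> 12 <= a + b + c + 1 -> realisable a b c -> realisable a b (c + 6).
Proof.
move=> c_ge9 v_ge12 abc_real; rewrite -[a]addn0 -[b]addn0.
apply: (realisable_grow (k := 6)) abc_real => //.
  by rewrite /block_widths c_ge9; case: (9 <= a); case: (10 <= b).
by apply: block_widths_grow; lia.
Qed.

Lemma realisable_admissible a b c :
  0 < a -> 0 < b -> 0 < c -> admissible a b c -> realisable a b c.
Proof.
move: {2}(a + b + c) (leqnn (a + b + c)) => n.
elim: n a b c => [|n IH] a b c size_abc a_gt0 b_gt0 c_gt0 /andP [v_ge12 six_dvd_v]; first lia.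
have [a_big | a_small] := leqP 10 a.
  rewrite (_ : a = a - 1 + 1); last lia.
  by apply: realisable_grow1 (IH _ _ _ _ _ b_gt0 c_gt0 _); rewrite /admissible; lia.
have [b_big | b_small] := leqP 12 b.
  rewrite (_ : b = b - 2 + 2); last lia.
  by apply: realisable_grow2 (IH _ _ _ _ a_gt0 _ c_gt0 _); rewrite /admissible; lia.
have [c_big | c_small] := leqP 15 c.
  rewrite (_ : c = c - 6 + 6); last lia.
  by apply: realisable_grow6 (IH _ _ _ _ a_gt0 b_gt0 _ _); rewrite /admissible; lia.
by apply: realisable_base; rewrite /admissible ?v_ge12; lia.
Qed.

Theorem proposition5p2 (a b c : nat) :
  1 <= a -> 1 <= b -> 1 <= c ->
  6 <= (a + b + c + 1)./2 ->
  (exists p : seq nat, ham_path (a + b + c + 1) p /\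
     perm_eq (path_lengths (a + b + c + 1) p) (L126 a b c))
  <->
  (forall d : nat, d %| (a + b + c + 1) ->
     count (fun x => d %| x) (L126 a b c) <= (a + b + c + 1) - d).
Proof.
move=> a_gt0 b_gt0 c_gt0 v_half; split.
  move=> [p [p_ham p_len]] d d_v.
  by rewrite -(permP p_len); apply: count_dvd_path_lengths.
move=> count_le.
have v_ge12 : 12 <= a + b + c + 1 by have := leq_half_double 6 (a + b + c + 1); lia.
have abc_adm : admissible a b c.
  rewrite /admissible v_ge12; apply/implyP => six_dvd.
  by have := count_le 6 six_dvd; rewrite /L126 !count_cat !count_nseq /=; lia.
have [p [bs [p_ham p_len _ _]]] := realisable_admissible a_gt0 b_gt0 c_gt0 abc_adm.
by exists p.
Qed.
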